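(* Let $1<p<\infty$, $N\ge1$, $0\le R_1<R_2<\infty$, and let $f$ satisfy: $(f_{\mathrm{reg}})$ $f\in C([0,\infty))\cap C^1((0,\infty))$; $(f_{\mathrm{eq}})$ $f(0)=f(1)=0$, $f(s)<0$ for $0<s<1$, $f(s)>0$ for $s>1$; $(f_0)$ there exists $C_0\in[0,\infty)$ with $\lim_{s\to0^+}f(s)/s^{p-1}=-C_0$; $(f_1)$ there exists $C_1\in[0,\infty]$ with $\lim_{s\to1}\frac{f(s)}{|s-1|^{p-2}(s-1)}=C_1$. Let $\hat f(s)=f(s)$ for $s\ge0$, $\hat f(s)=0$ for $s<0$, $\varphi_p(s)=|s|^{p-2}s$, and for $d\in[0,1]$ consider the Cauchy problem $$u'=\varphi_p^{-1}\Big(\frac{v}{r^{N-1}}\Big),\qquad v'=-r^{N-1}\hat f(u),\qquad u(R_1)=1-d,\ v(R_1)=0.$$ Then for every $d\in[0,1]$ the solution $(u_d,v_d)$ of this problem is unique and can be defined on the whole interval $[R_1,R_2]$; moreover, if $(d_n)\subset(0,1)$ and $d_n\to d\in[0,1]$, then $(u_{d_n}(r),v_{d_n}(r))\to(u_d(r),v_d(r))$ uniformly in $r\in[R_1,R_2]$.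
   Context: $\varphi_p^{-1}=\varphi_{p'}$ with $1/p+1/p'=1$. When $R_1=0$ the system is singular at $r=0$; a solution on an interval $[R_1,r^* )$ is then a pair $(u,v)$ such that $u$ and $v=r^{N-1}\varphi_p(u')$ are $C^1$, satisfy the equations for $r>0$ and the initial conditions (so that $u'(R_1)=0$). Uniqueness means uniqueness as long as the solution is defined. *)

From Stdlib Require Import Reals Lra.
From Coquelicot Require Import Coquelicot.
Open Scope R_scope.

(* varphi_p(s) = |s|^(p-2) s = sign(s) |s|^(p-1) *)
Definition phi_p (p s : R) : R :=
  if Rlt_dec 0 s then Rpower s (p - 1)
  else if Rlt_dec s 0 then - Rpower (- s) (p - 1)
  else 0.

(* conjugate exponent p' with 1/p + 1/p' = 1; varphi_p^{-1} = varphi_{p'} *)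
Definition conj_exp (p : R) : R := p / (p - 1).
Definition phi_p_inv (p s : R) : R := phi_p (conj_exp p) s.

Definition fhat (f : R -> R) (s : R) : R :=
  if Rle_dec 0 s then f s else 0.

(* (f_reg): f in C([0,oo)) /\ C^1((0,oo)) *)
Definition f_reg (f : R -> R) : Prop :=
  filterlim f (at_right 0) (locally (f 0)) /\
  (forall s, 0 < s -> ex_derive f s /\ continuous (Derive f) s).

Definition f_eq (f : R -> R) : Prop :=
  f 0 = 0 /\ f 1 = 0 /\
  (forall s, 0 < s < 1 -> f s < 0) /\
  (forall s, 1 < s -> 0 < f s).

Definition f_0 (p : R) (f : R -> R) : Prop :=
  exists C0 : R, 0 <= C0 /\
    filterlim (fun s => f s / Rpower s (p - 1)) (at_right 0) (locally (- C0)).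

Definition f_1 (p : R) (f : R -> R) : Prop :=
  exists C1 : Rbar, Rbar_le (Finite 0) C1 /\
    is_lim (fun s => f s / phi_p p (s - 1)) 1 C1.

Definition C1_on_Ico (g : R -> R) (a b : R) : Prop :=
  exists g' : R -> R,
    (forall r, a < r < b -> is_derive g r (g' r) /\ continuous g' r) /\
    filterlim (fun h => (g (a + h) - g a) / h) (at_right 0) (locally (g' a)) /\
    filterlim g' (at_right a) (locally (g' a)).

Definition is_solution (p : R) (N : nat) (f : R -> R) (R1 d : R)
    (u v : R -> R) (rs : R) : Prop :=
  R1 < rs /\
  C1_on_Ico u R1 rs /\ C1_on_Ico v R1 rs /\
  u R1 = 1 - d /\ v R1 = 0 /\
  (forall r, R1 < r < rs -> 0 < r ->
     is_derive u r (phi_p_inv p (v r / r ^ (N - 1))) /\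
     is_derive v r (- (r ^ (N - 1) * fhat f (u r)))).

(** Tonelli's delayed approximations, in which the right-hand side is evaluated
    at [r - h], are explicit, equibounded and equi-Lipschitz; by Arzela-Ascoli a subsequence
    converges uniformly and the limit is a solution, the right-hand sides converging locally
    uniformly on [(R1, R2]].  The a priori bound on [u'] comes from the energy
    [E = (p-1)/p |v / r^(N-1)|^p' + F(u)], [F] a primitive of [f], which is nonincreasing
    along solutions, so [f] may be truncated at a level that is never reached.

    Uniqueness, by continuous induction in [r].  The energy shows that the equilibrium
    [(u, v) = (1, 0)] is never left and that [u > 0] when [d < 1]; for [d = 1] the growth
    [|f(s)| <= K s^(p-1)] given by [(f_0)] forces [u = v = 0].  At any other point
    [w = v / r^(N-1)] is either nonzero or, as [f (u) <> 0], leaves [0] linearly, so along both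
    solutions [phi_p'] is Lipschitz enough for a Gronwall-type contraction on a short interval.

    Solutions with data [d_n] are equibounded and equi-Lipschitz on
    [[R1, R2]]; every subsequence thus has a uniformly convergent subsequence, whose limit is a
    solution with datum [d], hence is [(u_d, v_d)] by uniqueness. *)

From Stdlib Require Import Reals Lra Lia ZArith List ClassicalEpsilon.
From Coquelicot Require Import Coquelicot.
Open Scope R_scope.
Set Bullet Behavior "Strict Subproofs".

(** * Real-analysis preliminaries *)

Lemma ball_Rabs (x e y : R) : ball x e y <-> Rabs (y - x) < e.
Proof. reflexivity. Qed.

Lemma continuous_of_eps_delta (f : R -> R) x :
  (forall eps, 0 < eps -> exists d, 0 < d /\
     forall y, Rabs (y - x) < d -> Rabs (f y - f x) < eps) ->
  continuous f x.
Proof.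
  intros H. apply (proj2 (filterlim_locally f (f x))). intros [e he].
  destruct (H e he) as [d [hd Hd]]. exists (mkposreal d hd). intros y Hy. apply Hd, Hy.
Qed.

Lemma continuous_eps_delta (f : R -> R) x : continuous f x ->
  forall eps, 0 < eps -> exists d, 0 < d /\
    forall y, Rabs (y - x) < d -> Rabs (f y - f x) < eps.
Proof.
  intros H eps he.
  destruct (proj1 (filterlim_locally f (f x)) H (mkposreal eps he)) as [[d hd] Hd].
  exists d; split; [exact hd |]. intros y Hy. apply (Hd y Hy).
Qed.

Lemma is_derive_continuous (f : R -> R) x l : is_derive f x l -> continuous f x.
Proof.
  intros H. apply (ex_derive_continuous (K := R_AbsRing) (V := R_NormedModule)).
  exists l; exact H.
Qed.

Lemma locally_gt (x c : R) : c < x -> locally x (fun y => c < y).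
Proof. intros h. apply locally_interval with (a := Finite c) (b := p_infty); simpl; auto. Qed.

Lemma locally_lt (x c : R) : x < c -> locally x (fun y => y < c).
Proof. intros h. apply locally_interval with (a := m_infty) (b := Finite c); simpl; auto. Qed.

(** Coquelicot's arithmetic lemmas are stated with the [plus]/[minus]/[mult] of a normed
    module, which [apply] does not unify with [Rplus], [Rminus], ... *)

Lemma continuous_Rplus (f g : R -> R) x :
  continuous f x -> continuous g x -> continuous (fun y => f y + g y) x.
Proof. intros. apply (continuous_plus f g x); auto. Qed.

Lemma continuous_Rminus (f g : R -> R) x :
  continuous f x -> continuous g x -> continuous (fun y => f y - g y) x.
Proof. intros. apply (continuous_minus f g x); auto. Qed.

Lemma continuous_Rmult (f g : R -> R) x :
  continuous f x -> continuous g x -> continuous (fun y => f y * g y) x.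
Proof. intros. apply (continuous_mult f g x); auto. Qed.

Lemma continuous_Ropp (f : R -> R) x : continuous f x -> continuous (fun y => - f y) x.
Proof. intros. apply (continuous_opp f x); auto. Qed.

Lemma continuous_Rpow (f : R -> R) n x : continuous f x -> continuous (fun y => f y ^ n) x.
Proof.
  intros H. induction n; simpl; [apply continuous_const | now apply continuous_Rmult].
Qed.

Lemma is_derive_Rplus (f g : R -> R) (x a b : R) :
  is_derive f x a -> is_derive g x b -> is_derive (fun y => f y + g y) x (a + b).
Proof. intros. apply (is_derive_plus f g x a b); auto. Qed.

Lemma is_derive_Rminus (f g : R -> R) (x a b : R) :
  is_derive f x a -> is_derive g x b -> is_derive (fun y => f y - g y) x (a - b).
Proof. intros. apply (is_derive_minus f g x a b); auto. Qed.

Lemma is_derive_Ropp (f : R -> R) (x a : R) : is_derive f x a -> is_derive (fun y => - f y) x (- a).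
Proof. intros. apply (is_derive_opp f x a); auto. Qed.

Lemma is_derive_Rcomp (f g : R -> R) (x a b : R) :
  is_derive g x a -> is_derive f (g x) b -> is_derive (fun y => f (g y)) x (b * a).
Proof. intros H1 H2. rewrite Rmult_comm. exact (is_derive_comp f g x b a H2 H1). Qed.

Lemma is_derive_eq (f : R -> R) (x a b : R) : a = b -> is_derive f x a -> is_derive f x b.
Proof. now intros ->. Qed.

Definition right_continuous (g : R -> R) a := forall eps, 0 < eps -> exists d, 0 < d /\
  forall x, a <= x < a + d -> Rabs (g x - g a) < eps.

Lemma continuous_right_continuous g a : continuous g a -> right_continuous g a.
Proof.
  intros H eps he. destruct (continuous_eps_delta g a H eps he) as [d [hd Hd]].
  exists d; split; auto. intros x Hx. apply Hd. rewrite Rabs_right; lra.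
Qed.

Lemma right_continuous_of_is_derive (g : R -> R) a l : is_derive g a l -> right_continuous g a.
Proof. intros H. apply continuous_right_continuous, (is_derive_continuous g a l H). Qed.

Lemma right_continuous_of_filterlim g a :
  filterlim g (at_right a) (locally (g a)) -> right_continuous g a.
Proof.
  intros H eps he.
  destruct (proj1 (filterlim_locally g (g a)) H (mkposreal eps he)) as [[d hd] Hd].
  exists d; split; auto. intros x Hx. destruct (Req_dec x a) as [->|Hne].
  - rewrite Rminus_eq_0, Rabs_R0; auto.
  - apply (Hd x); [apply ball_Rabs; rewrite Rabs_right |]; simpl; lra.
Qed.

Lemma filterlim_of_right_continuous g a :
  right_continuous g a -> filterlim g (at_right a) (locally (g a)).
Proof.
  intros H. apply (proj2 (filterlim_locally g (g a))). intros [e he].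
  destruct (H e he) as [d [hd Hd]]. exists (mkposreal d hd). intros y Hy Hay.
  apply ball_Rabs, Hd. assert (Hy' : Rabs (y - a) < d) by exact Hy.
  rewrite Rabs_right in Hy'; lra.
Qed.

Lemma right_continuous_comp (u G : R -> R) a :
  right_continuous u a -> continuous G (u a) -> right_continuous (fun x => G (u x)) a.
Proof.
  intros Hu HG eps he. destruct (continuous_eps_delta G (u a) HG eps he) as [d1 [hd1 H1]].
  destruct (Hu d1 hd1) as [d2 [hd2 H2]]. exists d2; split; auto.
Qed.

Lemma right_continuous_minus (f g : R -> R) a :
  right_continuous f a -> right_continuous g a -> right_continuous (fun x => f x - g x) a.
Proof.
  intros Hf Hg eps he. destruct (Hf (eps/2) ltac:(lra)) as [d1 [hd1 H1]].
  destruct (Hg (eps/2) ltac:(lra)) as [d2 [hd2 H2]]. exists (Rmin d1 d2); split.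
  - apply Rmin_pos; auto.
  - intros x hx. assert (hm1 := Rmin_l d1 d2). assert (hm2 := Rmin_r d1 d2).
    specialize (H1 x ltac:(lra)). specialize (H2 x ltac:(lra)).
    replace (f x - g x - (f a - g a)) with ((f x - f a) - (g x - g a)) by ring.
    eapply Rle_lt_trans; [apply Rabs_triang |]. rewrite Rabs_Ropp. lra.
Qed.

Lemma right_continuous_abs (f : R -> R) a :
  right_continuous f a -> right_continuous (fun x => Rabs (f x)) a.
Proof.
  intros Hf eps he. destruct (Hf eps he) as [d [hd H]]. exists d; split; auto.
  intros x hx. eapply Rle_lt_trans; [apply Rabs_triang_inv2 | apply H; auto].
Qed.

Lemma right_continuous_mult (f g : R -> R) a :
  right_continuous f a -> right_continuous g a -> right_continuous (fun x => f x * g x) a.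
Proof.
  intros Hf Hg eps he.
  set (Mf := Rabs (f a) + 1). set (Mg := Rabs (g a) + 1).
  assert (hMf : 0 < Mf) by (unfold Mf; assert (0 <= Rabs (f a)) by apply Rabs_pos; lra).
  assert (hMg : 0 < Mg) by (unfold Mg; assert (0 <= Rabs (g a)) by apply Rabs_pos; lra).
  destruct (Hf (Rmin 1 (eps / (2 * Mg))) ltac:(apply Rmin_pos; [lra | apply Rdiv_lt_0_compat; lra]))
    as [d1 [hd1 H1]].
  destruct (Hg (eps / (2 * Mf)) ltac:(apply Rdiv_lt_0_compat; lra)) as [d2 [hd2 H2]].
  exists (Rmin d1 d2). split; [apply Rmin_pos; auto |]. intros x hx.
  assert (hm1 := Rmin_l d1 d2). assert (hm2 := Rmin_r d1 d2).
  specialize (H1 x ltac:(lra)). specialize (H2 x ltac:(lra)).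
  assert (hr1 := Rmin_l 1 (eps / (2 * Mg))). assert (hr2 := Rmin_r 1 (eps / (2 * Mg))).
  assert (Hfx : Rabs (f x) <= Mf).
  { unfold Mf. replace (f x) with ((f x - f a) + f a) by ring.
    eapply Rle_trans; [apply Rabs_triang | lra]. }
  assert (E1 : Rabs (f x) * Rabs (g x - g a) <= Mf * (eps / (2 * Mf))).
  { apply Rmult_le_compat; try apply Rabs_pos; lra. }
  assert (E2 : Rabs (g a) * Rabs (f x - f a) < Mg * (eps / (2 * Mg))).
  { apply Rle_lt_trans with (Mg * Rabs (f x - f a)).
    - apply Rmult_le_compat_r; [apply Rabs_pos | unfold Mg; lra].
    - apply Rmult_lt_compat_l; lra. }
  replace (Mf * (eps / (2 * Mf))) with (eps / 2) in E1 by (field; lra).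
  replace (Mg * (eps / (2 * Mg))) with (eps / 2) in E2 by (field; lra).
  replace (f x * g x - f a * g a) with (f x * (g x - g a) + g a * (f x - f a)) by ring.
  eapply Rle_lt_trans; [apply Rabs_triang |]. rewrite !Rabs_mult. lra.
Qed.

(** Extending [g] by [g a] to the left of [a] turns one-sided hypotheses at [a] into the
    two-sided ones required by the standard library. *)
Lemma continuity_pt_Rmax_left (g : R -> R) a c :
  right_continuous g a -> (a < c -> continuous g c) -> a <= c ->
  continuity_pt (fun x => g (Rmax a x)) c.
Proof.
  intros Hr Hc hc. apply continuity_pt_filterlim. destruct (Req_dec c a) as [->|hne].
  - apply (continuous_of_eps_delta (fun x => g (Rmax a x))). intros eps he.
    destruct (Hr eps he) as [d [hd Hd]]. exists d; split; auto. intros y hy. rewrite (Rmax_left a a) by lra.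
    destruct (Rle_dec y a).
    + rewrite Rmax_left, Rminus_eq_0, Rabs_R0 by lra. auto.
    + rewrite Rmax_right by lra. apply Hd. apply Rabs_def2 in hy. lra.
  - apply (continuous_ext_loc (fun x => g (Rmax a x)) g c).
    + apply (filter_imp (fun y => a < y)); [| apply locally_gt; lra].
      intros y hy. rewrite Rmax_right; lra.
    + apply Hc. lra.
Qed.

Lemma MVT_right_continuous (g dg : R -> R) a b : a < b ->
  (forall x, a < x < b -> is_derive g x (dg x)) -> right_continuous g a -> continuous g b ->
  exists c, a < c < b /\ g b - g a = dg c * (b - a).
Proof.
  intros hab Hd Hr Hb.
  set (h := fun x => g (Rmax a x)).
  assert (Hdh : forall x, a < x < b -> derivable_pt_lim h x (dg x)).
  { intros x hx. apply is_derive_Reals. apply is_derive_ext_loc with g; [| apply Hd; auto].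
    apply (filter_imp (fun y => a < y)); [| apply locally_gt; lra].
    intros y hy. unfold h. rewrite Rmax_right; lra. }
  assert (pr1 : forall c, a < c < b -> derivable_pt h c) by (intros c hc; exists (dg c); apply Hdh, hc).
  assert (pr2 : forall c, a < c < b -> derivable_pt id c) by (intros; apply derivable_pt_id).
  destruct (MVT h id a b pr1 pr2 hab) as [c [P HP]].
  { intros c hc. apply continuity_pt_Rmax_left; try lra; auto.
    intros hac. destruct (Req_dec c b) as [->|hcb]; auto.
    apply (is_derive_continuous g c (dg c)), Hd. lra. }
  { intros c hc. apply derivable_continuous_pt, derivable_pt_id. }
  exists c. split; auto.
  rewrite (derive_pt_eq_0 h c (dg c) (pr1 c P)) in HP by auto.
  rewrite (derive_pt_eq_0 id c 1 (pr2 c P)) in HP by apply derivable_pt_lim_id.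
  unfold h, id in HP. rewrite (Rmax_left a a), (Rmax_right a b) in HP by lra. lra.
Qed.

Lemma right_continuous_attains_max (g : R -> R) a b : a <= b ->
  right_continuous g a -> (forall x, a < x <= b -> continuous g x) ->
  exists r, a <= r <= b /\ forall x, a <= x <= b -> g x <= g r.
Proof.
  intros hab Hr Hc.
  destruct (continuity_ab_maj (fun x => g (Rmax a x)) a b hab) as [r [Hr1 Hr2]].
  { intros c hc. apply continuity_pt_Rmax_left; auto; try lra. intros; apply Hc; lra. }
  exists r. split; auto. intros x hx. specialize (Hr1 x hx). simpl in Hr1.
  rewrite !Rmax_right in Hr1 by lra. auto.
Qed.

Lemma Rabs_incr_le_of_derive_bound (g dg : R -> R) a b K : a <= b ->
  (forall x, a < x < b -> is_derive g x (dg x)) -> right_continuous g a -> continuous g b ->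
  (forall x, a < x < b -> Rabs (dg x) <= K) -> Rabs (g b - g a) <= K * (b - a).
Proof.
  intros hab Hd Hr Hb HK. destruct (Req_dec a b) as [->|hne].
  { rewrite !Rminus_eq_0, Rabs_R0, Rmult_0_r. lra. }
  destruct (MVT_right_continuous g dg a b ltac:(lra) Hd Hr Hb) as [c [hc Hc]].
  rewrite Hc, Rabs_mult, (Rabs_right (b - a)) by lra.
  apply Rmult_le_compat_r; [lra | apply HK; auto].
Qed.

Lemma incr_of_derive_nonneg (g dg : R -> R) a b : a <= b ->
  (forall x, a < x < b -> is_derive g x (dg x)) -> right_continuous g a -> continuous g b ->
  (forall x, a < x < b -> 0 <= dg x) -> g a <= g b.
Proof.
  intros hab Hd Hr Hb HK. destruct (Req_dec a b) as [->|hne]; [lra |].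
  destruct (MVT_right_continuous g dg a b ltac:(lra) Hd Hr Hb) as [c [hc Hc]].
  assert (0 <= dg c) by (apply HK; auto). nra.
Qed.

Lemma right_derivative_of_derive_limit (g h : R -> R) a b : a < b ->
  (forall x, a < x < b -> is_derive g x (h x)) -> right_continuous g a -> right_continuous h a ->
  filterlim (fun t => (g (a + t) - g a) / t) (at_right 0) (locally (h a)).
Proof.
  intros hab Hd Hg Hh. apply (proj2 (filterlim_locally _ (h a))). intros [e he].
  destruct (Hh e he) as [d [hd Hd']].
  exists (mkposreal (Rmin d (b - a)) ltac:(apply Rmin_pos; lra)). intros t Ht Htp.
  assert (Ht' : Rabs (t - 0) < Rmin d (b - a)) by exact Ht.
  rewrite Rminus_0_r, Rabs_right in Ht' by lra.
  assert (hm1 := Rmin_l d (b - a)). assert (hm2 := Rmin_r d (b - a)).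
  destruct (MVT_right_continuous g h a (a + t) ltac:(lra)) as [c [hc Hc]]; auto.
  { intros x hx. apply Hd. lra. }
  { apply (is_derive_continuous g _ (h (a + t))). apply Hd. lra. }
  apply ball_Rabs. simpl. replace ((g (a + t) - g a) / t) with (h c).
  - apply Hd'. lra.
  - rewrite Hc. field. lra.
Qed.

Lemma continuous_induction (Q : R -> Prop) a c : a < c -> Q a ->
  (forall r0, a <= r0 < c -> (forall x, a <= x <= r0 -> Q x) ->
     exists dl, 0 < dl /\ forall x, r0 <= x <= r0 + dl -> x < c -> Q x) ->
  (forall r0, a < r0 < c -> (forall x, a <= x < r0 -> Q x) -> Q r0) ->
  forall x, a <= x < c -> Q x.
Proof.
  intros hac Qa Hext Hcl.
  set (A := fun r => r <= c /\ forall x, a <= x <= r -> x < c -> Q x).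
  assert (HAa : A a).
  { split; [lra |]. intros x hx _. replace x with a by lra. auto. }
  destruct (completeness A ltac:(exists c; intros r [hr _]; auto) ltac:(exists a; auto))
    as [s [Hub Hlub]].
  assert (hsa : a <= s) by (apply Hub; auto).
  assert (hsc : s <= c) by (apply Hlub; intros r [hr _]; auto).
  assert (Hbelow : forall x, a <= x < s -> Q x).
  { intros x hx. destruct (Classical_Prop.classic (exists r, A r /\ x < r))
      as [[r [[hr1 hr2] hr3]]|hn]; [apply hr2; lra |].
    exfalso. assert (s <= x); [| lra]. apply Hlub. intros r hr.
    destruct (Rle_dec r x); auto. exfalso; apply hn; exists r; split; auto; lra. }
  destruct (Req_dec s c) as [->|hne]; [intros x hx; apply Hbelow; auto |].
  exfalso. assert (Qs : Q s).
  { destruct (Req_dec s a) as [->|]; auto. apply Hcl; [lra | auto]. }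
  destruct (Hext s ltac:(lra)) as [dl [hdl Hdl]].
  { intros x hx. destruct (Req_dec x s) as [->|]; auto. apply Hbelow; lra. }
  assert (HA : A (Rmin (s + dl) c)).
  { split; [apply Rmin_r |]. intros x hx hxc. assert (Rmin (s + dl) c <= s + dl) by apply Rmin_l.
    destruct (Rlt_dec x s); [apply Hbelow | apply Hdl]; auto; lra. }
  assert (Rmin (s + dl) c <= s) by (apply Hub; auto).
  unfold Rmin in *. destruct (Rle_dec (s + dl) c); lra.
Qed.

Lemma continuous_zero_of_zero_on_left (f : R -> R) a r0 : a < r0 -> continuous f r0 ->
  (forall y, a <= y < r0 -> f y = 0) -> f r0 = 0.
Proof.
  intros har Hc H. destruct (Req_dec (f r0) 0) as [|hn]; auto. exfalso.
  destruct (continuous_eps_delta f r0 Hc (Rabs (f r0)) ltac:(apply Rabs_pos_lt; auto))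
    as [e [he He]].
  set (y := Rmax a (r0 - e/2)).
  assert (hy1 : a <= y) by apply Rmax_l. assert (hy2 : r0 - e/2 <= y) by apply Rmax_r.
  assert (hy3 : y < r0) by (unfold y, Rmax; destruct (Rle_dec a (r0 - e/2)); lra).
  specialize (He y ltac:(rewrite Rabs_left by lra; lra)).
  rewrite H, Rminus_0_l, Rabs_Ropp in He by lra. lra.
Qed.

Lemma lipschitz_continuous (u : R -> R) a b K r : a < r < b -> 0 <= K ->
  (forall x y, a <= x <= b -> a <= y <= b -> Rabs (u x - u y) <= K * Rabs (x - y)) ->
  continuous u r.
Proof.
  intros hr hK H. apply continuous_of_eps_delta. intros eps he.
  exists (Rmin (eps / (K + 1)) (Rmin (r - a) (b - r))). split.
  { repeat apply Rmin_pos; try lra. apply Rdiv_lt_0_compat; lra. }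
  intros y hy. assert (h1 := Rmin_l (eps / (K + 1)) (Rmin (r - a) (b - r))).
  assert (h2 := Rmin_r (eps / (K + 1)) (Rmin (r - a) (b - r))).
  assert (h3 := Rmin_l (r - a) (b - r)). assert (h4 := Rmin_r (r - a) (b - r)).
  apply Rabs_def2 in hy as hy'.
  eapply Rle_lt_trans; [apply H; lra |].
  apply Rle_lt_trans with (K * (eps / (K + 1))); [apply Rmult_le_compat_l; lra |].
  apply Rlt_le_trans with ((K + 1) * (eps / (K + 1))); [| right; field; lra].
  apply Rmult_lt_compat_r; [apply Rdiv_lt_0_compat |]; lra.
Qed.

Lemma lipschitz_right_continuous (u : R -> R) a b K : a < b -> 0 <= K ->
  (forall x y, a <= x <= b -> a <= y <= b -> Rabs (u x - u y) <= K * Rabs (x - y)) ->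
  right_continuous u a.
Proof.
  intros hab hK H eps he. exists (Rmin (eps / (K + 1)) (b - a)). split.
  { apply Rmin_pos; try lra. apply Rdiv_lt_0_compat; lra. }
  intros x hx. assert (h1 := Rmin_l (eps / (K + 1)) (b - a)).
  assert (h2 := Rmin_r (eps / (K + 1)) (b - a)).
  eapply Rle_lt_trans; [apply H; lra |]. rewrite Rabs_right by lra.
  apply Rle_lt_trans with (K * (eps / (K + 1))); [apply Rmult_le_compat_l; lra |].
  apply Rlt_le_trans with ((K + 1) * (eps / (K + 1))); [| right; field; lra].
  apply Rmult_lt_compat_r; [apply Rdiv_lt_0_compat |]; lra.
Qed.

Lemma lipschitz_of_incr_bound (f : R -> R) a b L :
  (forall x y, a <= x <= y -> y <= b -> Rabs (f y - f x) <= L * (y - x)) ->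
  forall x y, a <= x <= b -> a <= y <= b -> Rabs (f x - f y) <= L * Rabs (x - y).
Proof.
  intros H x y hx hy. destruct (Rle_dec x y).
  - rewrite Rabs_minus_sym, (Rabs_minus_sym x), (Rabs_right (y - x)) by lra. apply H; lra.
  - rewrite (Rabs_right (x - y)) by lra. apply H; lra.
Qed.

Lemma eq_at_right_end_of_lipschitz (f1 f2 : R -> R) a r0 K : a < r0 -> 0 <= K ->
  (forall y, a <= y < r0 -> f1 y = f2 y) ->
  (forall y, a <= y <= r0 -> Rabs (f1 y - f1 r0) <= K * (r0 - y)) ->
  continuous f2 r0 -> f1 r0 = f2 r0.
Proof.
  intros har hK Heq Hl Hc. destruct (Req_dec (f1 r0) (f2 r0)) as [|hn]; auto. exfalso.
  set (e := Rabs (f1 r0 - f2 r0) / 2).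
  assert (he : 0 < e) by (unfold e; assert (0 < Rabs (f1 r0 - f2 r0)) by (apply Rabs_pos_lt; lra); lra).
  destruct (continuous_eps_delta f2 r0 Hc e he) as [dl [hdl Hdl]].
  set (t := Rmin (dl / 2) (e / (K + 1))).
  assert (hm1 := Rmin_l (dl / 2) (e / (K + 1))). assert (hm2 := Rmin_r (dl / 2) (e / (K + 1))).
  assert (hmp : 0 < t) by (apply Rmin_pos; [lra | apply Rdiv_lt_0_compat; lra]).
  set (y := Rmax a (r0 - t)).
  assert (hy1 : a <= y) by apply Rmax_l. assert (hy2 : r0 - t <= y) by apply Rmax_r.
  assert (hy3 : y < r0) by (unfold y, Rmax; destruct (Rle_dec a (r0 - t)); lra).
  specialize (Hdl y ltac:(rewrite Rabs_left by lra; unfold t in *; lra)).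
  specialize (Hl y ltac:(lra)). rewrite Heq in Hl by lra.
  assert (K * (r0 - y) <= e).
  { apply Rle_trans with ((K + 1) * (e / (K + 1))); [apply Rmult_le_compat; unfold t in *; lra |].
    right; field; lra. }
  assert (Rabs (f1 r0 - f2 r0) <= Rabs (f2 y - f1 r0) + Rabs (f2 y - f2 r0)).
  { replace (f1 r0 - f2 r0) with (- (f2 y - f1 r0) + (f2 y - f2 r0)) by ring.
    eapply Rle_trans; [apply Rabs_triang |]. rewrite Rabs_Ropp. lra. }
  unfold e in *. lra.
Qed.

(** * Powers and the function [phi_p] *)

Lemma Rpower_gt0 x e : 0 < Rpower x e.
Proof. apply exp_pos. Qed.

Lemma Rpower_le_endpoints x m M e : 0 < m -> m <= x <= M -> Rpower x e <= Rpower m e + Rpower M e.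
Proof.
  intros hm [h1 h2]. unfold Rpower.
  assert (ln m <= ln x) by (destruct (Req_dec m x) as [->|]; [lra | left; apply ln_increasing; lra]).
  assert (ln x <= ln M) by (destruct (Req_dec x M) as [->|]; [lra | left; apply ln_increasing; lra]).
  assert (0 < exp (e * ln m)) by apply exp_pos. assert (0 < exp (e * ln M)) by apply exp_pos.
  destruct (Rle_dec 0 e).
  - assert (exp (e * ln x) <= exp (e * ln M)); [| lra].
    destruct (Req_dec (e * ln x) (e * ln M)) as [E|]; [rewrite E; lra |].
    left; apply exp_increasing. nra.
  - assert (exp (e * ln x) <= exp (e * ln m)); [| lra].
    destruct (Req_dec (e * ln x) (e * ln m)) as [E|]; [rewrite E; lra |].
    left; apply exp_increasing. nra.
Qed.

Lemma Rpower_small e : 0 < e -> forall eps, 0 < eps ->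
  exists d, 0 < d /\ forall x, 0 < x < d -> Rpower x e < eps.
Proof.
  intros he eps heps. exists (Rpower eps (/ e)). split; [apply Rpower_gt0 |].
  intros x [hx1 hx2].
  assert (E : Rpower (Rpower eps (/ e)) e = eps).
  { rewrite Rpower_mult. replace (/ e * e) with 1 by (field; lra). apply Rpower_1; auto. }
  rewrite <- E. apply Rlt_Rpower_l; auto.
Qed.

Lemma Rpower_ge_base x e : 1 <= e -> 1 <= x -> x <= Rpower x e.
Proof.
  intros he hx. rewrite <- (Rpower_1 x) at 1 by lra. destruct (Req_dec x 1) as [->|].
  - unfold Rpower. rewrite ln_1, !Rmult_0_r. lra.
  - apply Rle_Rpower; lra.
Qed.

(** [x ^ e] for [x > 0], extended by [0]; thus [Rpower0 (Rabs s) e = |s|^e] for [e > 0]. *)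
Definition Rpower0 (x e : R) : R := if Rlt_dec 0 x then Rpower x e else 0.

Lemma Rpower0_pos x e : 0 < x -> Rpower0 x e = Rpower x e.
Proof. intros h. unfold Rpower0. destruct (Rlt_dec 0 x); [auto | lra]. Qed.

Lemma Rpower0_0 e : Rpower0 0 e = 0.
Proof. unfold Rpower0. destruct (Rlt_dec 0 0); [lra | auto]. Qed.

Lemma Rpower0_ge0 x e : 0 <= Rpower0 x e.
Proof. unfold Rpower0. destruct (Rlt_dec 0 x); [left; apply Rpower_gt0 | lra]. Qed.

Lemma Rpower0_le x y e : 0 <= e -> 0 <= x <= y -> Rpower0 x e <= Rpower0 y e.
Proof.
  intros he [h1 h2]. unfold Rpower0.
  destruct (Rlt_dec 0 x); destruct (Rlt_dec 0 y); try lra.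
  - apply Rle_Rpower_l; lra.
  - left; apply Rpower_gt0.
Qed.

Lemma Rpower0_mult x y e : 0 <= x -> 0 <= y -> Rpower0 (x * y) e = Rpower0 x e * Rpower0 y e.
Proof.
  intros hx hy. destruct (Req_dec x 0) as [->|hx']; [rewrite Rmult_0_l, Rpower0_0; ring |].
  destruct (Req_dec y 0) as [->|hy']; [rewrite Rmult_0_r, Rpower0_0; ring |].
  rewrite !Rpower0_pos by nra. rewrite Rpower_mult_distr; auto; lra.
Qed.

Lemma Rpower0_Rpower0 x e f : 0 <= x -> Rpower0 (Rpower0 x e) f = Rpower0 x (e * f).
Proof.
  intros hx. destruct (Req_dec x 0) as [->|hx']; [rewrite !Rpower0_0; reflexivity |].
  rewrite !(Rpower0_pos x) by lra. rewrite Rpower0_pos by apply Rpower_gt0.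
  apply Rpower_mult.
Qed.

Lemma Rpower0_1 x : 0 <= x -> Rpower0 x 1 = x.
Proof.
  intros hx. destruct (Req_dec x 0) as [->|]; [apply Rpower0_0 |].
  rewrite Rpower0_pos by lra. apply Rpower_1; lra.
Qed.

Lemma Rpower0_le1 x e : 0 <= e -> 0 <= x <= 1 -> Rpower0 x e <= 1.
Proof.
  intros he hx. destruct (Req_dec x 0) as [->|]; [rewrite Rpower0_0; lra |].
  rewrite Rpower0_pos by lra. unfold Rpower.
  assert (ln x <= 0).
  { destruct (Req_dec x 1) as [->|]; [rewrite ln_1; lra |].
    rewrite <- ln_1. left; apply ln_increasing; lra. }
  rewrite <- exp_0. destruct (Req_dec (e * ln x) 0) as [E|]; [rewrite E; lra |].
  left; apply exp_increasing; nra.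
Qed.

Lemma Rpower0_Rabs_small e : 0 < e -> forall eps, 0 < eps ->
  exists d, 0 < d /\ forall x, Rabs x < d -> Rpower0 (Rabs x) e < eps.
Proof.
  intros he eps heps. destruct (Rpower_small e he eps heps) as [d [hd Hd]].
  exists d; split; auto. intros x hx.
  destruct (Req_dec x 0) as [->|hn]; [rewrite Rabs_R0, Rpower0_0; auto |].
  assert (0 < Rabs x) by (apply Rabs_pos_lt; auto).
  rewrite Rpower0_pos by auto. apply Hd. lra.
Qed.

Lemma phi_p_pos q s : 0 < s -> phi_p q s = Rpower s (q - 1).
Proof. intros h. unfold phi_p. destruct (Rlt_dec 0 s); [auto | lra]. Qed.

Lemma phi_p_neg q s : s < 0 -> phi_p q s = - Rpower (- s) (q - 1).
Proof.
  intros h. unfold phi_p. destruct (Rlt_dec 0 s); [lra |].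
  destruct (Rlt_dec s 0); [auto | lra].
Qed.

Lemma phi_p_0 q : phi_p q 0 = 0.
Proof. unfold phi_p. destruct (Rlt_dec 0 0); [lra |]. destruct (Rlt_dec 0 0); [lra | auto]. Qed.

Lemma phi_p_mul_ge0 q s : 0 <= s * phi_p q s.
Proof.
  assert (0 < Rpower s (q - 1)) by apply Rpower_gt0.
  assert (0 < Rpower (- s) (q - 1)) by apply Rpower_gt0.
  destruct (Rtotal_order s 0) as [h|[->|h]].
  - rewrite phi_p_neg by auto. nra.
  - lra.
  - rewrite phi_p_pos by auto. nra.
Qed.

Lemma Rabs_phi_p q s : Rabs (phi_p q s) = Rpower0 (Rabs s) (q - 1).
Proof.
  destruct (Rtotal_order s 0) as [h|[->|h]].
  - rewrite phi_p_neg, Rpower0_pos by (auto; apply Rabs_pos_lt; lra).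
    rewrite Rabs_Ropp, Rabs_right by (left; apply Rpower_gt0). rewrite Rabs_left; auto.
  - rewrite phi_p_0, Rabs_R0, Rpower0_0. auto.
  - rewrite phi_p_pos, Rpower0_pos by (auto; apply Rabs_pos_lt; lra).
    rewrite Rabs_right by (left; apply Rpower_gt0). rewrite Rabs_right; lra.
Qed.

Lemma is_derive_phi_p q s : s <> 0 ->
  is_derive (phi_p q) s ((q - 1) * Rpower (Rabs s) (q - 2)).
Proof.
  intros hs. replace (q - 2) with (q - 1 - 1) by ring.
  destruct (Rtotal_order s 0) as [h|[h|h]]; [| lra |].
  - apply is_derive_ext_loc with (fun y => - Rpower (- y) (q - 1)).
    { apply (filter_imp (fun y => y < 0)); [| apply locally_lt; auto].
      intros y hy. rewrite phi_p_neg; auto. }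
    rewrite Rabs_left by auto.
    apply is_derive_eq with (- ((q - 1) * Rpower (- s) (q - 1 - 1) * (-1))); [ring |].
    apply is_derive_Ropp, (is_derive_Rcomp (fun y => Rpower y (q - 1)) (fun y => - y)).
    + apply is_derive_eq with (- 1); [ring |]. apply is_derive_Ropp; exact (is_derive_id _).
    + apply is_derive_Reals, derivable_pt_lim_power. lra.
  - apply is_derive_ext_loc with (fun y => Rpower y (q - 1)).
    { apply (filter_imp (fun y => 0 < y)); [| apply locally_gt; auto].
      intros y hy. rewrite phi_p_pos; auto. }
    rewrite Rabs_right by lra. apply is_derive_Reals, derivable_pt_lim_power. lra.
Qed.

Lemma continuous_phi_p q s : 1 < q -> continuous (phi_p q) s.
Proof.
  intros hq. destruct (Req_dec s 0) as [->|hs].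
  - apply continuous_of_eps_delta. intros eps he.
    destruct (Rpower0_Rabs_small (q - 1) ltac:(lra) eps he) as [d [hd Hd]].
    exists d; split; auto. intros y hy. rewrite phi_p_0, Rminus_0_r, Rabs_phi_p.
    apply Hd. rewrite Rminus_0_r in hy. auto.
  - apply (is_derive_continuous _ _ _ (is_derive_phi_p q s hs)).
Qed.

Lemma phi_p_lipschitz_off_0 q a b m M : 1 < q -> 0 < m ->
  m <= Rabs a <= M -> m <= Rabs b <= M -> 0 < a * b ->
  Rabs (phi_p q a - phi_p q b) <= (q - 1) * (Rpower m (q - 2) + Rpower M (q - 2)) * Rabs (a - b).
Proof.
  intros hq hm ha hb hab.
  assert (Hseg : forall c, Rmin b a <= c <= Rmax b a -> m <= Rabs c <= M).
  { intros c hc. unfold Rmin, Rmax in hc.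
    destruct (Rlt_dec 0 a).
    - assert (0 < b) by nra. rewrite Rabs_right in * by lra.
      destruct (Rle_dec b a); rewrite Rabs_right; lra.
    - assert (a < 0) by (destruct (Req_dec a 0); subst; nra).
      assert (b < 0) by nra. rewrite Rabs_left in * by lra.
      destruct (Rle_dec b a); rewrite Rabs_left; lra. }
  assert (Hn : forall c, Rmin b a <= c <= Rmax b a -> c <> 0).
  { intros c hc Hc. specialize (Hseg c hc). subst. rewrite Rabs_R0 in Hseg. lra. }
  destruct (MVT_gen (phi_p q) b a (fun c => (q - 1) * Rpower (Rabs c) (q - 2))) as [c [hc Hc]].
  { intros x hx. apply is_derive_phi_p, Hn. lra. }
  { intros x hx. apply continuity_pt_filterlim, continuous_phi_p; auto. }
  rewrite Hc, Rabs_mult, Rabs_minus_sym. apply Rmult_le_compat_r; [apply Rabs_pos |].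
  rewrite Rabs_right by (apply Rle_ge, Rmult_le_pos; [lra | left; apply Rpower_gt0]).
  apply Rmult_le_compat_l; [lra |]. apply Rpower_le_endpoints; auto.
Qed.

Lemma is_derive_Rpower0_Rabs q w : 1 < q ->
  is_derive (fun y => Rpower0 (Rabs y) q) w (q * phi_p q w).
Proof.
  intros hq. destruct (Rtotal_order w 0) as [h|[->|h]].
  - apply is_derive_ext_loc with (fun y => Rpower (- y) q).
    { apply (filter_imp (fun y => y < 0)); [| apply locally_lt; auto]. intros y hy.
      rewrite Rpower0_pos by (apply Rabs_pos_lt; lra). rewrite Rabs_left; auto. }
    rewrite phi_p_neg by auto.
    apply is_derive_eq with (q * Rpower (- w) (q - 1) * (-1)); [ring |].
    apply (is_derive_Rcomp (fun y => Rpower y q) (fun y => - y)).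
    + apply is_derive_eq with (- 1); [ring |]. apply is_derive_Ropp; exact (is_derive_id _).
    + apply is_derive_Reals, derivable_pt_lim_power. lra.
  - (* at 0 the difference quotient is [± |h|^(q-1)], which tends to 0 *)
    rewrite phi_p_0, Rmult_0_r. apply is_derive_Reals.
    intros eps he. destruct (Rpower0_Rabs_small (q - 1) ltac:(lra) eps he) as [d [hd Hd]].
    exists (mkposreal d hd). intros h hn hh. simpl in hh.
    assert (hh0 : 0 < Rabs h) by (apply Rabs_pos_lt; auto).
    rewrite Rplus_0_l, Rabs_R0, Rpower0_0, !Rminus_0_r, Rpower0_pos by auto.
    assert (E : Rpower (Rabs h) q = Rabs h * Rpower (Rabs h) (q - 1)).
    { replace q with (1 + (q - 1)) at 1 by ring. rewrite Rpower_plus, Rpower_1; auto. }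
    rewrite E.
    unfold Rdiv. rewrite Rabs_mult, Rabs_mult, Rabs_inv, Rabs_Rabsolu.
    rewrite (Rabs_right (Rpower _ _)) by (left; apply Rpower_gt0).
    replace (Rabs h * Rpower (Rabs h) (q - 1) * / Rabs h) with (Rpower (Rabs h) (q - 1))
      by (field; lra).
    specialize (Hd h hh). rewrite Rpower0_pos in Hd by auto. exact Hd.
  - apply is_derive_ext_loc with (fun y => Rpower y q).
    { apply (filter_imp (fun y => 0 < y)); [| apply locally_gt; auto]. intros y hy.
      rewrite Rpower0_pos by (apply Rabs_pos_lt; lra). rewrite Rabs_right; lra. }
    rewrite phi_p_pos by auto. apply is_derive_Reals, derivable_pt_lim_power. lra.
Qed.

Lemma conj_exp_gt1 p : 1 < p -> 1 < conj_exp p.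
Proof. intros hp. unfold conj_exp. apply (Rmult_lt_reg_r (p - 1)); [lra |]. field_simplify; lra. Qed.

Lemma conj_exp_minus1 p : 1 < p -> conj_exp p - 1 = / (p - 1).
Proof. intros hp. unfold conj_exp. field. lra. Qed.

(** * Nonlinearities, solutions and the energy *)

Lemma is_derive_RInt_upper (f : R -> R) a x : (forall z, continuous f z) ->
  is_derive (fun y => RInt f a y) x (f x).
Proof.
  intros Hc. apply (is_derive_RInt f (fun y => RInt f a y) a x); [| apply Hc].
  exists (mkposreal 1 Rlt_0_1). intros y _. apply (RInt_correct (V := R_CompleteNormedModule)).
  apply (ex_RInt_continuous (V := R_CompleteNormedModule)). intros; apply Hc.
Qed.

Lemma continuous_RInt_upper (f : R -> R) a x : (forall z, continuous f z) ->
  continuous (fun y => RInt f a y) x.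
Proof. intros Hc. apply (is_derive_continuous _ _ _ (is_derive_RInt_upper f a x Hc)). Qed.

Definition admissible (g : R -> R) : Prop :=
  (forall s, continuous g s) /\ (forall s, s <= 0 -> g s = 0) /\ g 1 = 0 /\
  (forall s, 0 < s < 1 -> g s < 0) /\ (forall s, 1 < s -> 0 < g s).

Definition primitive (g : R -> R) (s : R) : R := RInt g 0 s.

Section Primitive.
Variable g : R -> R.
Hypothesis Hg : admissible g.

Let Hgc : forall s, continuous g s := proj1 Hg.
Let Hg0 : forall s, s <= 0 -> g s = 0 := proj1 (proj2 Hg).
Let Hgneg : forall s, 0 < s < 1 -> g s < 0 := proj1 (proj2 (proj2 (proj2 Hg))).
Let Hgpos : forall s, 1 < s -> 0 < g s := proj2 (proj2 (proj2 (proj2 Hg))).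

Lemma is_derive_primitive s : is_derive (primitive g) s (g s).
Proof. apply is_derive_RInt_upper, Hgc. Qed.

Lemma continuous_primitive s : continuous (primitive g) s.
Proof. apply continuous_RInt_upper, Hgc. Qed.

Lemma primitive_0 : primitive g 0 = 0.
Proof. unfold primitive. rewrite RInt_point. reflexivity. Qed.

Lemma primitive_MVT x y : x < y ->
  exists c, x < c < y /\ primitive g y - primitive g x = g c * (y - x).
Proof.
  intros hxy. apply MVT_right_continuous; auto.
  - intros; apply is_derive_primitive.
  - apply continuous_right_continuous, continuous_primitive.
  - apply continuous_primitive.
Qed.

Lemma primitive_nonpos_arg s : s <= 0 -> primitive g s = 0.
Proof.
  intros hs. destruct (Req_dec s 0) as [->|hne]; [apply primitive_0 |].
  destruct (primitive_MVT s 0 ltac:(lra)) as [c [hc Hc']].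
  rewrite Hg0, primitive_0 in Hc' by lra. lra.
Qed.

Lemma primitive_decr_0_1 x y : 0 <= x < y -> y <= 1 -> primitive g y < primitive g x.
Proof.
  intros hx hy. destruct (primitive_MVT x y ltac:(lra)) as [c [hc Hc']].
  assert (g c < 0) by (apply Hgneg; lra). nra.
Qed.

Lemma primitive_incr_ge1 x y : 1 <= x < y -> primitive g x < primitive g y.
Proof.
  intros hx. destruct (primitive_MVT x y ltac:(lra)) as [c [hc Hc']].
  assert (0 < g c) by (apply Hgpos; lra). nra.
Qed.

Lemma primitive_lt0 s : 0 < s <= 1 -> primitive g s < 0.
Proof. intros hs. rewrite <- primitive_0. apply primitive_decr_0_1; lra. Qed.

Lemma primitive_le0 s : 0 <= s <= 1 -> primitive g s <= 0.
Proof.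
  intros hs. destruct (Req_dec s 0) as [->|hne]; [rewrite primitive_0; lra |].
  left; apply primitive_lt0; lra.
Qed.

Lemma primitive_strict_min s : s <> 1 -> primitive g 1 < primitive g s.
Proof.
  intros hs. destruct (Rle_dec s 0).
  - rewrite (primitive_nonpos_arg s) by auto. apply primitive_lt0; lra.
  - destruct (Rlt_dec s 1); [apply primitive_decr_0_1 | apply primitive_incr_ge1]; lra.
Qed.

Lemma primitive_min s : primitive g 1 <= primitive g s.
Proof.
  destruct (Req_dec s 1) as [->|hs]; [lra |]. left; apply primitive_strict_min; auto.
Qed.

End Primitive.

Definition is_solution_g (p : R) (N : nat) (g : R -> R) (R1 d : R) (u v : R -> R) (rs : R) : Prop :=
  R1 < rs /\
  C1_on_Ico u R1 rs /\ C1_on_Ico v R1 rs /\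
  u R1 = 1 - d /\ v R1 = 0 /\
  (forall r, R1 < r < rs -> 0 < r ->
     is_derive u r (phi_p_inv p (v r / r ^ (N - 1))) /\
     is_derive v r (- (r ^ (N - 1) * g (u r)))).

Lemma C1_on_Ico_right_continuous (g : R -> R) (a b : R) : C1_on_Ico g a b -> right_continuous g a.
Proof.
  intros [g' [_ [Hq _]]]. apply right_continuous_of_filterlim.
  apply (proj2 (filterlim_locally _ (g a))). intros [e he].
  destruct (proj1 (filterlim_locally _ (g' a)) Hq (mkposreal 1 Rlt_0_1)) as [[d1 hd1] H1].
  set (K := Rabs (g' a) + 1).
  assert (hK : 0 < K) by (unfold K; assert (0 <= Rabs (g' a)) by apply Rabs_pos; lra).
  exists (mkposreal (Rmin d1 (e / K)) ltac:(apply Rmin_pos; [auto | apply Rdiv_lt_0_compat; lra])).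
  intros y Hy Hay. apply ball_Rabs. simpl in *.
  assert (Hy' : Rabs (y - a) < Rmin d1 (e / K)) by exact Hy.
  rewrite Rabs_right in Hy' by lra.
  assert (hm1 := Rmin_l d1 (e / K)). assert (hm2 := Rmin_r d1 (e / K)).
  assert (Hb : ball 0 d1 (y - a)) by (apply ball_Rabs; rewrite Rminus_0_r, Rabs_right; lra).
  specialize (H1 (y - a) Hb ltac:(lra)).
  replace (a + (y - a)) with y in H1 by ring.
  assert (H1' : Rabs ((g y - g a) / (y - a) - g' a) < 1) by exact H1.
  assert (Hq' : Rabs ((g y - g a) / (y - a)) <= K).
  { unfold K. assert (H2 := Rabs_triang_inv ((g y - g a) / (y - a)) (g' a)). lra. }
  unfold Rdiv in Hq'. rewrite Rabs_mult, Rabs_inv, (Rabs_right (y - a)) in Hq' by lra.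
  assert (Rabs (g y - g a) <= K * (y - a)).
  { apply (Rmult_le_reg_r (/ (y - a))); [apply Rinv_0_lt_compat; lra |].
    rewrite Rmult_assoc, Rinv_r by lra. lra. }
  assert (K * (y - a) < e).
  { apply Rlt_le_trans with (K * (e / K)); [apply Rmult_lt_compat_l; lra | right; field; lra]. }
  lra.
Qed.

Section Solution.
Variables (p : R) (N : nat) (g : R -> R) (R1 d : R) (u v : R -> R) (rs : R).
Hypothesis hR1 : 0 <= R1.
Hypothesis Hs : is_solution_g p N g R1 d u v rs.

Lemma sol_interval : R1 < rs.
Proof. apply Hs. Qed.

Lemma sol_u_init : u R1 = 1 - d.
Proof. apply Hs. Qed.

Lemma sol_v_init : v R1 = 0.
Proof. apply Hs. Qed.

Lemma sol_derive_u r : R1 < r < rs -> is_derive u r (phi_p_inv p (v r / r ^ (N - 1))).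
Proof. intros h. apply Hs; lra. Qed.

Lemma sol_derive_v r : R1 < r < rs -> is_derive v r (- (r ^ (N - 1) * g (u r))).
Proof. intros h. apply Hs; lra. Qed.

Lemma sol_continuous_u r : R1 < r < rs -> continuous u r.
Proof. intros h. apply (is_derive_continuous _ _ _ (sol_derive_u r h)). Qed.

Lemma sol_continuous_v r : R1 < r < rs -> continuous v r.
Proof. intros h. apply (is_derive_continuous _ _ _ (sol_derive_v r h)). Qed.

Lemma sol_right_continuous_u r : R1 <= r < rs -> right_continuous u r.
Proof.
  intros h. destruct (Req_dec r R1) as [->|hne].
  - apply (C1_on_Ico_right_continuous _ _ rs), Hs.
  - apply continuous_right_continuous, sol_continuous_u; lra.
Qed.

Lemma sol_right_continuous_v r : R1 <= r < rs -> right_continuous v r.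
Proof.
  intros h. destruct (Req_dec r R1) as [->|hne].
  - apply (C1_on_Ico_right_continuous _ _ rs), Hs.
  - apply continuous_right_continuous, sol_continuous_v; lra.
Qed.

Lemma sol_v_incr_bound r0 x A : R1 <= r0 < x -> x < rs ->
  (forall c, r0 < c < x -> Rabs (g (u c)) <= A) ->
  Rabs (v x - v r0) <= A * x ^ (N - 1) * (x - r0).
Proof.
  intros h1 h2 HA.
  apply (Rabs_incr_le_of_derive_bound v (fun c => - (c ^ (N - 1) * g (u c)))); [lra | | | |].
  - intros c hc. apply sol_derive_v. lra.
  - apply sol_right_continuous_v. lra.
  - apply sol_continuous_v. lra.
  - intros c hc. rewrite Rabs_Ropp, Rabs_mult, Rabs_right by (apply Rle_ge, pow_le; lra).
    assert (c ^ (N - 1) <= x ^ (N - 1)) by (apply pow_incr; lra).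
    assert (0 <= Rabs (g (u c))) by apply Rabs_pos. assert (0 <= c ^ (N - 1)) by (apply pow_le; lra).
    specialize (HA c hc). rewrite Rmult_comm. apply Rmult_le_compat; lra.
Qed.

End Solution.

Arguments sol_interval {p N g R1 d u v rs} Hs.
Arguments sol_u_init {p N g R1 d u v rs} Hs.
Arguments sol_v_init {p N g R1 d u v rs} Hs.
Arguments sol_derive_u {p N g R1 d u v rs} hR1 Hs r.
Arguments sol_derive_v {p N g R1 d u v rs} hR1 Hs r.
Arguments sol_continuous_u {p N g R1 d u v rs} hR1 Hs r.
Arguments sol_continuous_v {p N g R1 d u v rs} hR1 Hs r.
Arguments sol_right_continuous_u {p N g R1 d u v rs} hR1 Hs r.
Arguments sol_right_continuous_v {p N g R1 d u v rs} hR1 Hs r.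
Arguments sol_v_incr_bound {p N g R1 d u v rs} hR1 Hs r0 x A.

Lemma Rabs_div_pow_le (x s A t : R) (N : nat) : 0 < s ->
  Rabs x <= A * s ^ (N - 1) * t -> Rabs (x / s ^ (N - 1)) <= A * t.
Proof.
  intros hs H. assert (hX : 0 < s ^ (N - 1)) by (apply pow_lt; auto).
  unfold Rdiv. rewrite Rabs_mult, Rabs_inv, (Rabs_right (s ^ (N - 1))) by lra.
  apply (Rmult_le_reg_r (s ^ (N - 1))); auto. rewrite Rmult_assoc, Rinv_l, Rmult_1_r by lra.
  lra.
Qed.

Lemma div_pow_ge (x s c : R) (N : nat) : 0 < s -> c * s ^ (N - 1) <= x -> c <= x / s ^ (N - 1).
Proof.
  intros hs H. assert (hX : 0 < s ^ (N - 1)) by (apply pow_lt; auto).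
  apply (Rmult_le_reg_r (s ^ (N - 1))); auto.
  unfold Rdiv. rewrite Rmult_assoc, Rinv_l, Rmult_1_r by lra. auto.
Qed.

Lemma continuous_div_pow (v : R -> R) (N : nat) r : 0 < r -> continuous v r ->
  continuous (fun y => v y / y ^ (N - 1)) r.
Proof.
  intros hr Hv. apply continuous_Rmult; auto.
  apply continuous_Rinv_comp; [apply continuous_Rpow, continuous_id |].
  apply Rgt_not_eq, pow_lt; auto.
Qed.

(** Here [w = v / r^(N-1)] is [phi_p (u')]; [energy] is a first integral when [N = 1] and
    is nonincreasing in general. *)
Section Energy.
Variables (p : R) (N : nat) (g : R -> R) (R1 d : R) (u v : R -> R) (rs : R).
Hypothesis hp : 1 < p.
Hypothesis hR1 : 0 <= R1.
Hypothesis Hg : admissible g.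
Hypothesis Hs : is_solution_g p N g R1 d u v rs.

Definition energy (r : R) :=
  (p - 1) / p * Rpower0 (Rabs (v r / r ^ (N - 1))) (conj_exp p) + primitive g (u r).

Lemma is_derive_energy r : R1 < r < rs -> is_derive energy r
  (- (INR (N - 1) / r * (v r / r ^ (N - 1) * phi_p (conj_exp p) (v r / r ^ (N - 1))))).
Proof.
  intros hr. assert (r0 : 0 < r) by lra. assert (hX : 0 < r ^ (N - 1)) by (apply pow_lt; auto).
  set (w := v r / r ^ (N - 1)). set (q := conj_exp p).
  assert (Hdw : is_derive (fun y => v y / y ^ (N - 1)) r
     ((- (r ^ (N - 1) * g (u r)) * r ^ (N - 1)
       - v r * (INR (N - 1) * 1 * r ^ Init.Nat.pred (N - 1))) / (r ^ (N - 1)) ^ 2)).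
  { apply (is_derive_div v (fun y => y ^ (N - 1))); [apply (sol_derive_v hR1 Hs); lra | | lra].
    apply (is_derive_pow (fun y => y)). exact (is_derive_id _). }
  unfold energy.
  apply is_derive_eq with ((p - 1) / p * ((q * phi_p q w) *
     ((- (r ^ (N - 1) * g (u r)) * r ^ (N - 1)
       - v r * (INR (N - 1) * 1 * r ^ Init.Nat.pred (N - 1))) / (r ^ (N - 1)) ^ 2))
     + g (u r) * phi_p_inv p w).
  - unfold phi_p_inv. fold q. unfold w.
    replace ((p - 1) / p) with (/ q) by (unfold q, conj_exp; field; lra).
    assert (1 < q) by (apply conj_exp_gt1; auto).
    destruct (N - 1)%nat as [|k]; cbn [pow Init.Nat.pred].
    + change (INR 0) with 0. field. lra.
    + assert (0 < r ^ k) by (apply pow_lt; auto). field. lra.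
  - apply is_derive_Rplus.
    + apply (is_derive_scal (fun y => Rpower0 (Rabs (v y / y ^ (N - 1))) q)).
      apply (is_derive_Rcomp (fun w => Rpower0 (Rabs w) q) (fun y => v y / y ^ (N - 1))); auto.
      apply is_derive_eq with (q * phi_p q w); [ring |].
      apply is_derive_Rpower0_Rabs, conj_exp_gt1; auto.
    + apply (is_derive_Rcomp (primitive g) u); [apply (sol_derive_u hR1 Hs); lra |].
      apply is_derive_primitive; auto.
Qed.

Lemma sol_w_small_at_init eps : 0 < eps ->
  exists dl, 0 < dl /\ forall x, R1 < x < R1 + dl -> Rabs (v x / x ^ (N - 1)) < eps.
Proof.
  intros he. assert (hrs := sol_interval Hs).
  destruct (right_continuous_comp u g R1 (sol_right_continuous_u hR1 Hs R1 ltac:(lra))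
              (proj1 Hg (u R1)) 1 Rlt_0_1) as [e [he1 He]].
  set (A := Rabs (g (u R1)) + 1).
  assert (hA : 0 < A) by (unfold A; assert (0 <= Rabs (g (u R1))) by apply Rabs_pos; lra).
  exists (Rmin (Rmin e (rs - R1)) (eps / A)).
  split; [repeat apply Rmin_pos; try lra; apply Rdiv_lt_0_compat; lra |].
  intros x hx. assert (hm1 := Rmin_l (Rmin e (rs - R1)) (eps / A)).
  assert (hm2 := Rmin_r (Rmin e (rs - R1)) (eps / A)).
  assert (hm3 := Rmin_l e (rs - R1)). assert (hm4 := Rmin_r e (rs - R1)).
  assert (H := sol_v_incr_bound hR1 Hs R1 x A ltac:(lra) ltac:(lra)).
  rewrite (sol_v_init Hs), Rminus_0_r in H.
  eapply Rle_lt_trans; [apply (Rabs_div_pow_le _ _ A); [lra | apply H] |].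
  - intros c hc. specialize (He c ltac:(lra)). unfold A.
    assert (H3 := Rabs_triang_inv (g (u c)) (g (u R1))). lra.
  - apply Rlt_le_trans with (A * (eps / A)); [apply Rmult_lt_compat_l; lra | right; field; lra].
Qed.

Lemma energy_init : energy R1 = primitive g (1 - d).
Proof.
  unfold energy. rewrite (sol_v_init Hs), (sol_u_init Hs).
  unfold Rdiv. rewrite Rmult_0_l, Rabs_R0, Rpower0_0. ring.
Qed.

Lemma right_continuous_energy_init : right_continuous energy R1.
Proof.
  intros eps he. assert (hrs := sol_interval Hs). assert (Hq := conj_exp_gt1 p hp).
  assert (hc : 0 < (p - 1) / p) by (apply Rdiv_lt_0_compat; lra).
  destruct (right_continuous_comp u (primitive g) R1
              (sol_right_continuous_u hR1 Hs R1 ltac:(lra)) (continuous_primitive g Hg (u R1))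
              (eps/2) ltac:(lra)) as [d1 [hd1 H1]].
  destruct (Rpower0_Rabs_small (conj_exp p) ltac:(lra) (eps / 2 / ((p - 1) / p)))
    as [d2 [hd2 H2]]; [apply Rdiv_lt_0_compat; lra |].
  destruct (sol_w_small_at_init d2 hd2) as [d3 [hd3 H3]].
  exists (Rmin d1 d3). split; [apply Rmin_pos; auto |].
  intros x hx. assert (hm1 := Rmin_l d1 d3). assert (hm2 := Rmin_r d1 d3).
  destruct (Req_dec x R1) as [->|hne]; [rewrite Rminus_eq_0, Rabs_R0; auto |].
  rewrite energy_init. unfold energy. specialize (H1 x ltac:(lra)).
  rewrite (sol_u_init Hs) in H1.
  specialize (H2 _ (H3 x ltac:(lra))).
  set (a := Rpower0 (Rabs (v x / x ^ (N - 1))) (conj_exp p)) in *.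
  assert (0 <= a) by apply Rpower0_ge0.
  assert (E : (p - 1) / p * a < eps / 2).
  { apply (Rmult_lt_compat_l ((p - 1) / p)) in H2; auto.
    replace ((p - 1) / p * (eps / 2 / ((p - 1) / p))) with (eps / 2) in H2 by (field; lra). auto. }
  replace ((p - 1) / p * a + primitive g (u x) - primitive g (1 - d))
    with ((p - 1) / p * a + (primitive g (u x) - primitive g (1 - d))) by ring.
  eapply Rle_lt_trans; [apply Rabs_triang |].
  rewrite Rabs_right by (apply Rle_ge, Rmult_le_pos; lra). lra.
Qed.

Lemma energy_decr a b : R1 <= a <= b -> b < rs -> energy b <= energy a.
Proof.
  intros hab hb. destruct (Req_dec a b) as [->|hne]; [lra |].
  destruct (MVT_right_continuous energy
    (fun c => - (INR (N - 1) / c * (v c / c ^ (N - 1) * phi_p (conj_exp p) (v c / c ^ (N - 1)))))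
    a b ltac:(lra)) as [c [hc Hc]].
  - intros x hx. apply is_derive_energy; lra.
  - destruct (Req_dec a R1) as [->|]; [apply right_continuous_energy_init |].
    apply (right_continuous_of_is_derive _ _ _ (is_derive_energy a ltac:(lra))).
  - apply (is_derive_continuous _ _ _ (is_derive_energy b ltac:(lra))).
  - assert (0 <= INR (N - 1) / c) by (apply Rdiv_le_0_compat; [apply pos_INR | lra]).
    assert (Hm := phi_p_mul_ge0 (conj_exp p) (v c / c ^ (N - 1))).
    assert (0 <= INR (N - 1) / c * (v c / c ^ (N - 1) * phi_p (conj_exp p) (v c / c ^ (N - 1))))
      by (apply Rmult_le_pos; auto).
    nra.
Qed.

Lemma energy_le_init r : R1 <= r < rs -> energy r <= primitive g (1 - d).
Proof. intros h. rewrite <- energy_init. apply energy_decr; lra. Qed.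

Lemma sol_stays_at_1 r0 : R1 <= r0 < rs -> u r0 = 1 -> v r0 = 0 ->
  forall x, r0 <= x < rs -> u x = 1 /\ v x = 0.
Proof.
  intros hr0 hu hv x hx. assert (H := energy_decr r0 x ltac:(lra) ltac:(lra)).
  unfold energy in H. rewrite hu, hv in H.
  replace (0 / r0 ^ (N - 1)) with 0 in H by (unfold Rdiv; ring).
  rewrite Rabs_R0, Rpower0_0, Rmult_0_r, Rplus_0_l in H.
  set (a := Rpower0 (Rabs (v x / x ^ (N - 1))) (conj_exp p)) in H.
  assert (ha : 0 <= a) by apply Rpower0_ge0.
  assert (hc : 0 < (p - 1) / p) by (apply Rdiv_lt_0_compat; lra).
  assert (hG := primitive_min g Hg (u x)).
  assert (Hu : u x = 1).
  { destruct (Req_dec (u x) 1) as [|hn]; auto. assert (H2 := primitive_strict_min g Hg (u x) hn). nra. }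
  split; auto. rewrite Hu in H. assert (Ha : a = 0) by nra.
  destruct (Req_dec x r0) as [->|hne]; auto.
  assert (hX : 0 < x ^ (N - 1)) by (apply pow_lt; lra).
  destruct (Req_dec (v x) 0) as [|hn]; auto. exfalso.
  assert (0 < Rabs (v x / x ^ (N - 1))).
  { apply Rabs_pos_lt. unfold Rdiv. apply Rmult_integral_contrapositive.
    split; auto. apply Rinv_neq_0_compat. lra. }
  unfold a in Ha. rewrite Rpower0_pos in Ha by auto.
  assert (H3 := Rpower_gt0 (Rabs (v x / x ^ (N - 1))) (conj_exp p)). lra.
Qed.

(** With [G = primitive g]: [energy <= G (1 - d) <= 0] and [G >= G 1] give
    [|w|^p' <= p/(p-1) (- G 1)]. *)
Definition w_bound := Rmax 1 (p / (p - 1) * (- primitive g 1)).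

Definition slope_bound := Rpower w_bound (conj_exp p - 1).

Lemma sol_w_bounded r : 0 <= d <= 1 -> R1 <= r < rs -> Rabs (v r / r ^ (N - 1)) <= w_bound.
Proof.
  intros hd hr. assert (H := energy_le_init r hr). unfold energy in H.
  assert (HG1 := primitive_min g Hg (u r)).
  assert (HG2 := primitive_le0 g Hg (1 - d) ltac:(lra)).
  assert (hc : 0 < (p - 1) / p) by (apply Rdiv_lt_0_compat; lra).
  set (a := Rpower0 (Rabs (v r / r ^ (N - 1))) (conj_exp p)) in H.
  assert (Ha : a <= p / (p - 1) * (- primitive g 1)).
  { apply (Rmult_le_reg_l ((p - 1) / p)); auto.
    replace ((p - 1) / p * (p / (p - 1) * - primitive g 1)) with (- primitive g 1)
      by (field; lra). lra. }
  unfold w_bound. assert (h1 := Rmax_l 1 (p / (p - 1) * - primitive g 1)).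
  assert (h2 := Rmax_r 1 (p / (p - 1) * - primitive g 1)).
  destruct (Rle_dec (Rabs (v r / r ^ (N - 1))) 1); [lra |].
  assert (Rabs (v r / r ^ (N - 1)) <= a); [| lra].
  unfold a. rewrite Rpower0_pos by lra. apply Rpower_ge_base; [| lra].
  assert (Hq := conj_exp_gt1 p hp). lra.
Qed.

Lemma slope_bound_ge0 : 0 <= slope_bound.
Proof. left; apply Rpower_gt0. Qed.

Lemma sol_derive_u_bounded r : 0 <= d <= 1 -> R1 <= r < rs ->
  Rabs (phi_p_inv p (v r / r ^ (N - 1))) <= slope_bound.
Proof.
  intros hd hr. unfold phi_p_inv, slope_bound. rewrite Rabs_phi_p.
  assert (Hw := sol_w_bounded r hd hr). assert (Hq := conj_exp_gt1 p hp).
  assert (H1 : 1 <= w_bound) by apply Rmax_l.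
  unfold Rpower0. destruct (Rlt_dec 0 (Rabs (v r / r ^ (N - 1)))).
  - apply Rle_Rpower_l; lra.
  - left; apply Rpower_gt0.
Qed.

End Energy.

Arguments energy_le_init {p N g R1 d u v rs} hp hR1 Hg Hs r.
Arguments sol_stays_at_1 {p N g R1 d u v rs} hp hR1 Hg Hs r0.
Arguments sol_derive_u_bounded {p N g R1 d u v rs} hp hR1 Hg Hs r.

(** * Uniqueness *)

Lemma vanish_of_derive_le_sup (f df : R -> R) a b k : a < b -> f a = 0 ->
  0 <= k -> k * (b - a) < 1 ->
  (forall y, a < y < b -> is_derive f y (df y)) -> right_continuous f a ->
  (forall y, a < y <= b -> continuous f y) ->
  (forall M, (forall y, a <= y <= b -> Rabs (f y) <= M) ->
     forall y, a < y < b -> Rabs (df y) <= k * M) ->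
  forall y, a <= y <= b -> f y = 0.
Proof.
  intros hab hfa hk0 hk Hd Hr Hc Hdf.
  destruct (right_continuous_attains_max (fun y => Rabs (f y)) a b ltac:(lra)) as [rho [hrho Hrho]].
  { apply right_continuous_abs, Hr. }
  { intros y hy. apply continuous_Rabs_comp, Hc, hy. }
  set (M := Rabs (f rho)) in *. assert (hM0 : 0 <= M) by apply Rabs_pos.
  assert (HM : M = 0).
  { destruct (Req_dec rho a) as [E|hne]; [unfold M; rewrite E, hfa, Rabs_R0; auto |].
    destruct (MVT_right_continuous f df a rho ltac:(lra)) as [xi [hxi Hxi]]; auto.
    { intros y hy. apply Hd. lra. }
    { apply Hc. lra. }
    rewrite hfa, Rminus_0_r in Hxi.
    assert (Hb := Hdf M Hrho xi ltac:(lra)).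
    assert (M <= k * M * (rho - a)).
    { unfold M at 1. rewrite Hxi, Rabs_mult, (Rabs_right (rho - a)) by lra.
      apply Rmult_le_compat_r; lra. }
    assert (k * M * (rho - a) <= k * M * (b - a)) by (apply Rmult_le_compat_l; nra).
    nra. }
  intros y hy. apply Rabs_eq_0, Rle_antisym; [| apply Rabs_pos]. rewrite <- HM. apply Hrho, hy.
Qed.

Section ZeroSolution.
Variables (p : R) (N : nat) (g : R -> R) (R1 d : R) (u v : R -> R) (rs : R).
Hypothesis hp : 1 < p.
Hypothesis hR1 : 0 <= R1.
Hypothesis Hs : is_solution_g p N g R1 d u v rs.
Variable K : R.
Hypothesis hK : 0 < K.
Hypothesis Hgrow : forall s, Rabs s <= 1 -> Rabs (g s) <= K * Rpower0 (Rabs s) (p - 1).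

(** Near a zero [(u, v) = (0, 0)], [|w| <= K dl M^(p-1)] with [M = sup |u| <= 1], hence
    [|u'| = |w|^(p'-1) <= (K dl)^(p'-1) M <= M]. *)
Lemma sol_derive_u_le_sup_near_0 r0 x dl M xi : R1 <= r0 < x -> x < rs -> x - r0 <= dl -> K * dl <= 1 ->
  u r0 = 0 -> v r0 = 0 -> (forall y, r0 <= y <= x -> Rabs (u y) <= 1) ->
  (forall y, r0 <= y <= x -> Rabs (u y) <= M) -> r0 < xi < x ->
  Rabs (phi_p_inv p (v xi / xi ^ (N - 1))) <= M.
Proof.
  intros hr0 hx hdl hKdl hu hv Hu1 HM hxi. assert (Hq := conj_exp_gt1 p hp).
  set (m := Rmin M 1).
  assert (hm : 0 <= m) by (apply Rmin_glb; [eapply Rle_trans; [apply Rabs_pos | apply (HM r0); lra] | lra]).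
  assert (Hum : forall y, r0 <= y <= x -> Rabs (u y) <= m) by (intros; apply Rmin_glb; auto).
  set (B := K * Rpower0 m (p - 1)).
  assert (hB : 0 <= B) by (apply Rmult_le_pos; [lra | apply Rpower0_ge0]).
  assert (Hv := sol_v_incr_bound hR1 Hs r0 xi B ltac:(lra) ltac:(lra)).
  rewrite hv, Rminus_0_r in Hv.
  assert (Hw : Rabs (v xi / xi ^ (N - 1)) <= (K * dl) * Rpower0 m (p - 1)).
  { replace ((K * dl) * Rpower0 m (p - 1)) with (B * dl) by (unfold B; ring).
    apply Rabs_div_pow_le; [lra |]. eapply Rle_trans.
    - apply Hv. intros c hc. eapply Rle_trans; [apply Hgrow, Hu1; lra |].
      apply Rmult_le_compat_l; [lra |]. apply Rpower0_le; [lra | split; [apply Rabs_pos | apply Hum; lra]].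
    - apply Rmult_le_compat_l; [| lra]. apply Rmult_le_pos; [auto | apply pow_le; lra]. }
  unfold phi_p_inv. rewrite Rabs_phi_p.
  eapply Rle_trans; [apply Rpower0_le; [lra | split; [apply Rabs_pos | apply Hw]] |].
  assert (0 <= K * dl) by (apply Rmult_le_pos; lra).
  rewrite Rpower0_mult by (auto; apply Rpower0_ge0).
  rewrite Rpower0_Rpower0, conj_exp_minus1, Rinv_r, Rpower0_1 by lra.
  assert (Rpower0 (K * dl) (/ (p - 1)) <= 1).
  { apply Rpower0_le1; [left; apply Rinv_0_lt_compat; lra | lra]. }
  assert (m <= M) by apply Rmin_l.
  assert (0 <= Rpower0 (K * dl) (/ (p - 1))) by apply Rpower0_ge0. nra.
Qed.

Lemma sol_zero_locally r0 : R1 <= r0 < rs -> u r0 = 0 -> v r0 = 0 ->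
  exists dl, 0 < dl /\ forall x, r0 <= x <= r0 + dl -> x < rs -> u x = 0 /\ v x = 0.
Proof.
  intros hr0 hu hv.
  destruct (sol_right_continuous_u hR1 Hs r0 hr0 1 Rlt_0_1) as [d0 [hd0 Hd0]].
  rewrite hu in Hd0.
  set (dl := Rmin (d0 / 2) (Rmin (1/2) (1 / K))).
  assert (hdl1 : dl <= d0 / 2) by apply Rmin_l.
  assert (hdl2 : dl <= 1/2) by (eapply Rle_trans; [apply Rmin_r | apply Rmin_l]).
  assert (hdl3 : dl <= 1/K) by (eapply Rle_trans; [apply Rmin_r | apply Rmin_r]).
  assert (hdl : 0 < dl) by (repeat apply Rmin_pos; try lra; apply Rdiv_lt_0_compat; lra).
  assert (hKdl : K * dl <= 1)
    by (apply Rle_trans with (K * (1 / K)); [apply Rmult_le_compat_l; lra | right; field; lra]).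
  exists dl. split; auto. intros x hx hxr.
  destruct (Req_dec x r0) as [->|hne]; [auto |].
  assert (Hu1 : forall y, r0 <= y <= x -> Rabs (u y) <= 1).
  { intros y hy. specialize (Hd0 y ltac:(lra)). rewrite Rminus_0_r in Hd0. lra. }
  assert (Hzero : forall y, r0 <= y <= x -> u y = 0).
  { apply (vanish_of_derive_le_sup u (fun y => phi_p_inv p (v y / y ^ (N - 1))) r0 x 1);
      auto; try lra.
    - intros y hy. apply (sol_derive_u hR1 Hs). lra.
    - apply (sol_right_continuous_u hR1 Hs). lra.
    - intros y hy. apply (sol_continuous_u hR1 Hs). lra.
    - intros M HM xi hxi. rewrite Rmult_1_l.
      apply (sol_derive_u_le_sup_near_0 r0 x dl); auto; lra. }
  split; [apply Hzero; lra |].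
  assert (Hv := sol_v_incr_bound hR1 Hs r0 x 0 ltac:(lra) ltac:(lra)).
  rewrite hv, Rminus_0_r, !Rmult_0_l in Hv. apply Rabs_eq_0, Rle_antisym; [| apply Rabs_pos].
  apply Hv. intros c hc. rewrite Hzero by lra.
  eapply Rle_trans; [apply Hgrow; rewrite Rabs_R0; lra |].
  rewrite Rabs_R0, Rpower0_0, Rmult_0_r. lra.
Qed.

Lemma sol_zero_if_d1 : d = 1 -> forall x, R1 <= x < rs -> u x = 0 /\ v x = 0.
Proof.
  intros hd. apply continuous_induction; [apply (sol_interval Hs) | | |].
  - split; [rewrite (sol_u_init Hs); lra | apply (sol_v_init Hs)].
  - intros r0 hr0 HQ. destruct (HQ r0 ltac:(lra)) as [h1 h2]. apply sol_zero_locally; auto.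
  - intros r0 hr0 HQ. split.
    + apply (continuous_zero_of_zero_on_left u R1 r0); [lra | apply (sol_continuous_u hR1 Hs); lra |].
      intros y hy; apply HQ; auto.
    + apply (continuous_zero_of_zero_on_left v R1 r0); [lra | apply (sol_continuous_v hR1 Hs); lra |].
      intros y hy; apply HQ; auto.
Qed.

End ZeroSolution.

Lemma pow_diff_ge (r0 s : R) (N : nat) : 0 <= r0 <= s -> (1 <= N)%nat ->
  s ^ (N - 1) * (s - r0) <= s ^ N - r0 ^ N.
Proof.
  intros [h1 h2] hN. destruct N as [|M]; [lia |]. simpl. rewrite Nat.sub_0_r.
  assert (r0 ^ M <= s ^ M) by (apply pow_incr; lra).
  assert (0 <= r0 ^ M) by (apply pow_le; lra). nra.
Qed.

Lemma lower_bound_of_derive_ge (F dF : R -> R) (N : nat) r0 s a :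
  (1 <= N)%nat -> 0 <= r0 < s -> 0 <= a -> F r0 = 0 ->
  (forall y, r0 < y < s -> is_derive F y (dF y)) -> right_continuous F r0 -> continuous F s ->
  (forall y, r0 < y < s -> a * y ^ (N - 1) <= dF y) ->
  a / INR N * s ^ (N - 1) * (s - r0) <= F s.
Proof.
  intros hN hs ha H0 Hd Hr Hc Hb.
  assert (hNp : 0 < INR N) by (apply lt_0_INR; lia).
  set (h := fun y => F y - a * y ^ N / INR N).
  assert (Hdp : forall y, is_derive (fun y => a * y ^ N / INR N) y (a * (INR N * 1 * y ^ Init.Nat.pred N) / INR N)).
  { intros y. auto_derive; [auto | field; lra]. }
  assert (Hh : h r0 <= h s).
  { apply (incr_of_derive_nonneg h (fun y => dF y - a * (INR N * 1 * y ^ Init.Nat.pred N) / INR N));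
      [lra | | | |].
    - intros y hy. apply is_derive_Rminus; [apply Hd; auto | apply Hdp].
    - apply right_continuous_minus; auto.
      apply (right_continuous_of_is_derive _ _ _ (Hdp r0)).
    - apply continuous_Rminus; auto. apply (is_derive_continuous _ _ _ (Hdp s)).
    - intros y hy. rewrite <- Nat.sub_1_r. specialize (Hb y hy).
      replace (a * (INR N * 1 * y ^ (N - 1)) / INR N) with (a * y ^ (N - 1)) by (field; lra).
      lra. }
  unfold h in Hh. rewrite H0 in Hh.
  assert (Hp := pow_diff_ge r0 s N ltac:(lra) hN).
  assert (a * (s ^ (N - 1) * (s - r0)) <= a * (s ^ N - r0 ^ N)) by (apply Rmult_le_compat_l; lra).
  apply (Rmult_le_compat_r (/ INR N)) in H; [| left; apply Rinv_0_lt_compat; lra].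
  unfold Rdiv in *. nra.
Qed.

(** The factor by which [sup |u1 - u2|] contracts on a step of length [dl] in the local
    uniqueness argument, with [C1 = c^(q-2)] and [C2 = Wm^(q-2)] (see [pinched] below). *)
Definition contraction_rate (q L C1 C2 dl : R) := (q - 1) * L * (C1 * Rpower dl (q - 1) + C2 * dl).

Lemma contraction_rate_ge0 q L C1 C2 dl : 1 < q -> 0 <= L -> 0 <= C1 -> 0 <= C2 -> 0 <= dl ->
  0 <= contraction_rate q L C1 C2 dl.
Proof.
  intros hq hL h1 h2 hdl. unfold contraction_rate. assert (0 < Rpower dl (q - 1)) by apply Rpower_gt0.
  apply Rmult_le_pos; [apply Rmult_le_pos |]; nra.
Qed.

Lemma contraction_rate_small (q L C1 C2 : R) : 1 < q -> 0 <= L -> 0 <= C1 -> 0 <= C2 -> forall d0, 0 < d0 ->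
  exists dl, 0 < dl /\ dl <= d0 /\ contraction_rate q L C1 C2 dl * dl < 1.
Proof.
  intros hq hL h1 h2 d0 hd0. unfold contraction_rate.
  set (D := 2 * ((q - 1) * (L + 1) * (C1 + C2 + 1))).
  assert (hD : 0 < D) by (unfold D; repeat apply Rmult_lt_0_compat; lra).
  set (eta := / D). assert (heta : 0 < eta) by (apply Rinv_0_lt_compat; auto).
  destruct (Rpower_small (q - 1) ltac:(lra) eta heta) as [e [he He]].
  set (dl := Rmin (Rmin d0 1) (Rmin (e / 2) eta)).
  assert (hd1 : dl <= d0) by (eapply Rle_trans; [apply Rmin_l | apply Rmin_l]).
  assert (hd2 : dl <= 1) by (eapply Rle_trans; [apply Rmin_l | apply Rmin_r]).
  assert (hd3 : dl <= e / 2) by (eapply Rle_trans; [apply Rmin_r | apply Rmin_l]).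
  assert (hd4 : dl <= eta) by (eapply Rle_trans; [apply Rmin_r | apply Rmin_r]).
  assert (hdl : 0 < dl) by (unfold dl; repeat apply Rmin_pos; lra).
  exists dl. split; [auto | split; auto].
  assert (HR : Rpower dl (q - 1) < eta) by (apply He; lra).
  assert (0 < Rpower dl (q - 1)) by apply Rpower_gt0.
  assert (E : C1 * Rpower dl (q - 1) + C2 * dl <= (C1 + C2) * eta) by nra.
  assert (E2 : (q - 1) * L * (C1 * Rpower dl (q - 1) + C2 * dl) * dl <= (q - 1) * L * ((C1 + C2) * eta) * 1).
  { apply Rmult_le_compat; [| lra | | lra].
    - apply Rmult_le_pos; [apply Rmult_le_pos |]; nra.
    - apply Rmult_le_compat_l; [apply Rmult_le_pos |]; lra. }
  assert ((q - 1) * L * ((C1 + C2) * eta) < 1); [| lra].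
  unfold eta. apply (Rmult_lt_reg_r D); auto. rewrite Rmult_1_l.
  replace ((q - 1) * L * ((C1 + C2) * / D) * D) with ((q - 1) * L * (C1 + C2)) by (field; lra).
  assert (0 < (q - 1) * (L + 1) * (C1 + C2 + 1)) by (repeat apply Rmult_lt_0_compat; lra).
  assert ((q - 1) * L * (C1 + C2) <= (q - 1) * (L + 1) * (C1 + C2 + 1)).
  { apply Rmult_le_compat; [apply Rmult_le_pos | | apply Rmult_le_compat_l |]; lra. }
  unfold D. lra.
Qed.

Definition locally_lipschitz_on_pos (g : R -> R) := forall a b, 0 < a -> a <= b ->
  exists L, 0 <= L /\ forall x y, a <= x <= b -> a <= y <= b -> Rabs (g x - g y) <= L * Rabs (x - y).

Section TurningPoint.
Variables (p : R) (N : nat) (g : R -> R) (R1 d : R) (u v : R -> R) (rs : R).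
Hypothesis hN : (1 <= N)%nat.
Hypothesis hR1 : 0 <= R1.
Hypothesis Hs : is_solution_g p N g R1 d u v rs.

Lemma sol_w_near_turning_point r0 db a g0 :
  R1 <= r0 -> r0 + db < rs -> 0 < a -> Rabs g0 = 2 * a -> v r0 = 0 ->
  (forall y, r0 <= y <= r0 + db -> Rabs (g (u y) - g0) < a) ->
  forall s, r0 < s <= r0 + db ->
    Rabs (v s / s ^ (N - 1)) <= 3 * a * (s - r0) /\
    (g0 < 0 -> a / INR N * (s - r0) <= v s / s ^ (N - 1)) /\
    (0 < g0 -> a / INR N * (s - r0) <= - (v s / s ^ (N - 1))).
Proof.
  intros h0 hrs ha hg0 hv Gy s hs.
  assert (hX : 0 < s ^ (N - 1)) by (apply pow_lt; lra).
  split; [| split; intros hsg].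
  - apply Rabs_div_pow_le; [lra |].
    assert (HH := sol_v_incr_bound hR1 Hs r0 s (3 * a) ltac:(lra) ltac:(lra)).
    rewrite hv, Rminus_0_r in HH. apply HH. intros c hc. specialize (Gy c ltac:(lra)).
    assert (H3 := Rabs_triang_inv (g (u c)) g0). lra.
  - apply div_pow_ge; [lra |]. rewrite Rmult_assoc, (Rmult_comm (s - r0)), <- Rmult_assoc.
    apply (lower_bound_of_derive_ge v (fun y => - (y ^ (N - 1) * g (u y))) N r0 s a);
      auto; try lra.
    + intros y hy. apply (sol_derive_v hR1 Hs); lra.
    + apply (sol_right_continuous_v hR1 Hs); lra.
    + apply (sol_continuous_v hR1 Hs); lra.
    + intros y hy. specialize (Gy y ltac:(lra)). apply Rabs_def2 in Gy.
      rewrite Rabs_left in hg0 by lra.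
      assert (0 <= y ^ (N - 1)) by (apply pow_le; lra). nra.
  - replace (- (v s / s ^ (N - 1))) with ((- v s) / s ^ (N - 1)) by (field; lra).
    apply div_pow_ge; [lra |]. rewrite Rmult_assoc, (Rmult_comm (s - r0)), <- Rmult_assoc.
    apply (lower_bound_of_derive_ge (fun y => - v y) (fun y => - - (y ^ (N - 1) * g (u y))) N r0 s a);
      auto; try lra.
    + intros y hy. apply is_derive_Ropp, (sol_derive_v hR1 Hs); lra.
    + intros eps he.
      destruct (sol_right_continuous_v hR1 Hs r0 ltac:(lra) eps he) as [e [he' He']].
      exists e; split; auto. intros x hx. replace (- v x - - v r0) with (- (v x - v r0)) by ring.
      rewrite Rabs_Ropp; auto.
    + apply continuous_Ropp, (sol_continuous_v hR1 Hs); lra.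
    + intros y hy. specialize (Gy y ltac:(lra)). apply Rabs_def2 in Gy.
      rewrite Rabs_right in hg0 by lra.
      assert (0 <= y ^ (N - 1)) by (apply pow_le; lra). nra.
Qed.

End TurningPoint.

Section TwoSolutions.
Variables (p : R) (N : nat) (g : R -> R) (R1 d : R) (u1 v1 u2 v2 : R -> R) (rs1 rs2 : R).
Hypothesis hp : 1 < p.
Hypothesis hR1 : 0 <= R1.
Hypothesis Hs1 : is_solution_g p N g R1 d u1 v1 rs1.
Hypothesis Hs2 : is_solution_g p N g R1 d u2 v2 rs2.

Let w1 s := v1 s / s ^ (N - 1).
Let w2 s := v2 s / s ^ (N - 1).

(** [phi_p'] is not Lipschitz at [0]; on [(r0, r0 + db]] the two [w]'s keep a common sign
    and stay at distance [>= c (s - r0)] from [0], which is enough for a contraction. *)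
Definition pinched r0 db c Wm := forall s, r0 < s <= r0 + db ->
  0 < w1 s * w2 s /\ c * (s - r0) <= Rabs (w1 s) <= Wm /\ c * (s - r0) <= Rabs (w2 s) <= Wm.

Lemma sols_v_diff_bound r0 x L M : R1 <= r0 < x -> x < rs1 -> x < rs2 -> v1 r0 = v2 r0 -> 0 <= L ->
  (forall s, r0 < s <= x -> Rabs (g (u1 s) - g (u2 s)) <= L * Rabs (u1 s - u2 s)) ->
  (forall s, r0 <= s <= x -> Rabs (u1 s - u2 s) <= M) ->
  forall xi, r0 < xi <= x -> Rabs (v1 xi - v2 xi) <= L * M * xi ^ (N - 1) * (xi - r0).
Proof.
  intros hr0 h1 h2 hv hL HL HM xi hxi.
  replace (v1 xi - v2 xi) with ((v1 xi - v2 xi) - (v1 r0 - v2 r0)) by (rewrite hv; ring).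
  apply (Rabs_incr_le_of_derive_bound (fun y => v1 y - v2 y)
           (fun y => - (y ^ (N - 1) * g (u1 y)) - - (y ^ (N - 1) * g (u2 y)))); [lra | | | |].
  - intros y hy. apply is_derive_Rminus; [apply (sol_derive_v hR1 Hs1) | apply (sol_derive_v hR1 Hs2)]; lra.
  - apply right_continuous_minus;
      [apply (sol_right_continuous_v hR1 Hs1) | apply (sol_right_continuous_v hR1 Hs2)]; lra.
  - apply continuous_Rminus; [apply (sol_continuous_v hR1 Hs1) | apply (sol_continuous_v hR1 Hs2)]; lra.
  - intros y hy.
    replace (- (y ^ (N - 1) * g (u1 y)) - - (y ^ (N - 1) * g (u2 y)))
      with (- (y ^ (N - 1) * (g (u1 y) - g (u2 y)))) by ring.
    rewrite Rabs_Ropp, Rabs_mult, Rabs_right by (apply Rle_ge, pow_le; lra).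
    assert (y ^ (N - 1) <= xi ^ (N - 1)) by (apply pow_incr; lra).
    assert (0 <= y ^ (N - 1)) by (apply pow_le; lra).
    assert (Rabs (g (u1 y) - g (u2 y)) <= L * M).
    { eapply Rle_trans; [apply HL; lra |].
      apply Rmult_le_compat_l; [lra | apply HM; lra]. }
    assert (0 <= Rabs (g (u1 y) - g (u2 y))) by apply Rabs_pos.
    replace (L * M * xi ^ (N - 1)) with (xi ^ (N - 1) * (L * M)) by ring.
    apply Rmult_le_compat; lra.
Qed.

Lemma sols_phi_w_diff_bound r0 dl L c Wm M xi :
  R1 <= r0 -> r0 + dl < rs1 -> r0 + dl < rs2 -> v1 r0 = v2 r0 -> 0 <= L -> 0 < c ->
  (forall s, r0 < s <= r0 + dl -> Rabs (g (u1 s) - g (u2 s)) <= L * Rabs (u1 s - u2 s)) ->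
  pinched r0 dl c Wm -> (forall s, r0 <= s <= r0 + dl -> Rabs (u1 s - u2 s) <= M) ->
  r0 < xi < r0 + dl ->
  Rabs (phi_p_inv p (w1 xi) - phi_p_inv p (w2 xi))
    <= contraction_rate (conj_exp p) L (Rpower c (conj_exp p - 2)) (Rpower Wm (conj_exp p - 2)) dl * M.
Proof.
  intros h0 hr1 hr2 hv hL hc HL Hpin HM hxi.
  assert (Hq := conj_exp_gt1 p hp). set (q := conj_exp p) in *. set (t := xi - r0).
  assert (hM : 0 <= M) by (eapply Rle_trans; [apply Rabs_pos | apply (HM r0); lra]).
  assert (hX : 0 < xi ^ (N - 1)) by (apply pow_lt; lra).
  assert (Hw : Rabs (w1 xi - w2 xi) <= L * M * t).
  { unfold w1, w2. replace (v1 xi / xi ^ (N - 1) - v2 xi / xi ^ (N - 1))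
      with ((v1 xi - v2 xi) / xi ^ (N - 1)) by (field; lra).
    apply Rabs_div_pow_le; [lra |]. apply (sols_v_diff_bound r0 (r0 + dl)); auto; lra. }
  destruct (Hpin xi ltac:(lra)) as [Hsg [H1 H2]].
  assert (Hphi := phi_p_lipschitz_off_0 q (w1 xi) (w2 xi) (c * t) Wm Hq
                    ltac:(apply Rmult_lt_0_compat; unfold t; lra) H1 H2 Hsg).
  assert (Hct : Rpower (c * t) (q - 2) * t <= Rpower c (q - 2) * Rpower dl (q - 1)).
  { rewrite <- Rpower_mult_distr by (unfold t; lra). rewrite Rmult_assoc.
    apply Rmult_le_compat_l; [left; apply Rpower_gt0 |].
    replace (Rpower t (q - 2) * t) with (Rpower t (q - 1)).
    - apply Rle_Rpower_l; unfold t in *; lra.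
    - replace (q - 1) with ((q - 2) + 1) by ring.
      rewrite Rpower_plus, Rpower_1 by (unfold t; lra). ring. }
  assert (HWt : Rpower Wm (q - 2) * t <= Rpower Wm (q - 2) * dl).
  { apply Rmult_le_compat_l; [left; apply Rpower_gt0 | unfold t; lra]. }
  unfold phi_p_inv. fold q. eapply Rle_trans; [apply Hphi |].
  assert (0 < Rpower (c * t) (q - 2)) by apply Rpower_gt0.
  assert (0 < Rpower Wm (q - 2)) by apply Rpower_gt0.
  apply Rle_trans with ((q - 1) * (Rpower (c * t) (q - 2) + Rpower Wm (q - 2)) * (L * M * t)).
  - apply Rmult_le_compat_l; [apply Rmult_le_pos |]; lra.
  - replace ((q - 1) * (Rpower (c * t) (q - 2) + Rpower Wm (q - 2)) * (L * M * t))
      with ((q - 1) * L * M * (Rpower (c * t) (q - 2) * t + Rpower Wm (q - 2) * t)) by ring.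
    unfold contraction_rate.
    replace ((q - 1) * L * (Rpower c (q - 2) * Rpower dl (q - 1) + Rpower Wm (q - 2) * dl) * M)
      with ((q - 1) * L * M * (Rpower c (q - 2) * Rpower dl (q - 1) + Rpower Wm (q - 2) * dl)) by ring.
    apply Rmult_le_compat_l; [apply Rmult_le_pos; [apply Rmult_le_pos |] |]; lra.
Qed.

Lemma sols_agree_of_pinched r0 dl L c Wm :
  R1 <= r0 -> 0 < dl -> r0 + dl < rs1 -> r0 + dl < rs2 -> u1 r0 = u2 r0 -> v1 r0 = v2 r0 ->
  0 <= L -> 0 < c -> 0 < Wm ->
  (forall s, r0 < s <= r0 + dl -> Rabs (g (u1 s) - g (u2 s)) <= L * Rabs (u1 s - u2 s)) ->
  pinched r0 dl c Wm ->
  contraction_rate (conj_exp p) L (Rpower c (conj_exp p - 2)) (Rpower Wm (conj_exp p - 2)) dl * dl < 1 ->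
  forall x, r0 <= x <= r0 + dl -> u1 x = u2 x /\ v1 x = v2 x.
Proof.
  intros h0 hdl hr1 hr2 hu hv hL hc hW HL Hpin Hsmall.
  assert (Hq := conj_exp_gt1 p hp).
  assert (Hu : forall x, r0 <= x <= r0 + dl -> u1 x - u2 x = 0).
  { apply (vanish_of_derive_le_sup (fun y => u1 y - u2 y)
             (fun y => phi_p_inv p (w1 y) - phi_p_inv p (w2 y)) r0 (r0 + dl)
             (contraction_rate (conj_exp p) L (Rpower c (conj_exp p - 2)) (Rpower Wm (conj_exp p - 2)) dl));
      try lra.
    - apply contraction_rate_ge0; auto; [left; apply Rpower_gt0 | left; apply Rpower_gt0 | lra].
    - intros y hy. apply is_derive_Rminus; [apply (sol_derive_u hR1 Hs1) | apply (sol_derive_u hR1 Hs2)]; lra.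
    - apply right_continuous_minus;
        [apply (sol_right_continuous_u hR1 Hs1) | apply (sol_right_continuous_u hR1 Hs2)]; lra.
    - intros y hy. apply continuous_Rminus;
        [apply (sol_continuous_u hR1 Hs1) | apply (sol_continuous_u hR1 Hs2)]; lra.
    - intros M HM xi hxi. apply (sols_phi_w_diff_bound r0 dl L c Wm M xi); auto. }
  intros x hx. split; [specialize (Hu x hx); lra |].
  destruct (Req_dec x r0) as [->|hne]; auto.
  assert (Hv := sols_v_diff_bound r0 (r0 + dl) L 0 ltac:(lra) hr1 hr2 hv hL
                  ltac:(intros; apply HL; lra)
                  ltac:(intros s hs; rewrite Hu, Rabs_R0 by lra; lra) x ltac:(lra)).
  rewrite Rmult_0_r, !Rmult_0_l in Hv.
  assert (Rabs (v1 x - v2 x) = 0) by (apply Rle_antisym; [auto | apply Rabs_pos]).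
  apply Rabs_eq_0 in H. lra.
Qed.

Lemma pinched_at_turning_point r0 da : (1 <= N)%nat -> (forall s, continuous g s) ->
  R1 <= r0 -> 0 < da -> r0 + da < rs1 -> r0 + da < rs2 ->
  u1 r0 = u2 r0 -> v1 r0 = 0 -> v2 r0 = 0 -> g (u1 r0) <> 0 ->
  exists c Wm db, 0 < c /\ 0 < Wm /\ 0 < db /\ db < da /\ pinched r0 db c Wm.
Proof.
  intros hN Hgc h0 hda hr1 hr2 hu hv1 hv2 hg0.
  set (g0 := g (u1 r0)). set (a := Rabs g0 / 2).
  assert (ha : 0 < a) by (unfold a; assert (0 < Rabs g0) by (apply Rabs_pos_lt; auto); lra).
  destruct (continuous_eps_delta g (u1 r0) (Hgc (u1 r0)) a ha) as [e [he He]].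
  destruct (sol_right_continuous_u hR1 Hs1 r0 ltac:(lra) e he) as [e1 [he1 He1]].
  destruct (sol_right_continuous_u hR1 Hs2 r0 ltac:(lra) e he) as [e2 [he2 He2]].
  rewrite <- hu in He2.
  set (db := Rmin (Rmin (da / 2) 1) (Rmin (e1 / 2) (e2 / 2))).
  assert (hdb1 : db <= da / 2) by (eapply Rle_trans; [apply Rmin_l | apply Rmin_l]).
  assert (hdb2 : db <= 1) by (eapply Rle_trans; [apply Rmin_l | apply Rmin_r]).
  assert (hdb3 : db <= e1 / 2) by (eapply Rle_trans; [apply Rmin_r | apply Rmin_l]).
  assert (hdb4 : db <= e2 / 2) by (eapply Rle_trans; [apply Rmin_r | apply Rmin_r]).
  assert (hdb : 0 < db) by (unfold db; repeat apply Rmin_pos; lra).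
  assert (hNp : 0 < INR N) by (apply lt_0_INR; lia).
  exists (a / INR N), (3 * a), db.
  split; [apply Rdiv_lt_0_compat; lra | split; [lra | split; [auto | split; [lra |]]]].
  intros s hs.
  assert (Hg2a : Rabs g0 = 2 * a) by (unfold a; field).
  destruct (sol_w_near_turning_point p N g R1 d u1 v1 rs1 hN hR1 Hs1 r0 db a g0
              h0 ltac:(lra) ha Hg2a hv1 ltac:(intros; apply He, He1; lra) s hs) as [U1 [L1a L1b]].
  destruct (sol_w_near_turning_point p N g R1 d u2 v2 rs2 hN hR1 Hs2 r0 db a g0
              h0 ltac:(lra) ha Hg2a hv2 ltac:(intros; apply He, He2; lra) s hs) as [U2 [L2a L2b]].
  fold (w1 s) in U1, L1a, L1b. fold (w2 s) in U2, L2a, L2b.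
  assert (hc : 0 < a / INR N * (s - r0)) by (apply Rmult_lt_0_compat; [apply Rdiv_lt_0_compat |]; lra).
  assert (3 * a * (s - r0) <= 3 * a) by nra.
  destruct (Rlt_dec g0 0) as [hneg|hpos].
  - specialize (L1a hneg). specialize (L2a hneg).
    rewrite (Rabs_right (w1 s)), (Rabs_right (w2 s)) in * by lra. split; [nra | lra].
  - assert (hpos' : 0 < g0) by (destruct (Req_dec g0 0); [contradiction | lra]).
    specialize (L1b hpos'). specialize (L2b hpos').
    rewrite (Rabs_left (w1 s)), (Rabs_left (w2 s)) in * by lra. split; [nra | lra].
Qed.

Lemma pinched_at_regular_point r0 da :
  R1 <= r0 -> 0 < da -> r0 + da < rs1 -> r0 + da < rs2 -> v1 r0 = v2 r0 -> v1 r0 <> 0 ->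
  exists c Wm db, 0 < c /\ 0 < Wm /\ 0 < db /\ db < da /\ pinched r0 db c Wm.
Proof.
  intros h0 hda hr1 hr2 hv hv0.
  assert (hr0 : R1 < r0).
  { destruct (Req_dec r0 R1) as [E|]; [| lra]. exfalso. apply hv0. rewrite E. apply (sol_v_init Hs1). }
  assert (hX : 0 < r0 ^ (N - 1)) by (apply pow_lt; lra).
  assert (hw0 : 0 < Rabs (w1 r0)).
  { apply Rabs_pos_lt. unfold w1, Rdiv. apply Rmult_integral_contrapositive.
    split; auto. apply Rinv_neq_0_compat; lra. }
  assert (Hw : w2 r0 = w1 r0) by (unfold w1, w2; rewrite hv; auto).
  destruct (continuous_eps_delta w1 r0
              (continuous_div_pow v1 N r0 ltac:(lra) (sol_continuous_v hR1 Hs1 r0 ltac:(lra)))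
              (Rabs (w1 r0) / 2) ltac:(lra)) as [e1 [he1 He1]].
  destruct (continuous_eps_delta w2 r0
              (continuous_div_pow v2 N r0 ltac:(lra) (sol_continuous_v hR1 Hs2 r0 ltac:(lra)))
              (Rabs (w1 r0) / 2) ltac:(lra)) as [e2 [he2 He2]].
  rewrite Hw in He2.
  set (db := Rmin (Rmin (da / 2) 1) (Rmin (e1 / 2) (e2 / 2))).
  assert (hdb1 : db <= da / 2) by (eapply Rle_trans; [apply Rmin_l | apply Rmin_l]).
  assert (hdb2 : db <= 1) by (eapply Rle_trans; [apply Rmin_l | apply Rmin_r]).
  assert (hdb3 : db <= e1 / 2) by (eapply Rle_trans; [apply Rmin_r | apply Rmin_l]).
  assert (hdb4 : db <= e2 / 2) by (eapply Rle_trans; [apply Rmin_r | apply Rmin_r]).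
  assert (hdb : 0 < db) by (unfold db; repeat apply Rmin_pos; lra).
  exists (Rabs (w1 r0) / 2), (3 * Rabs (w1 r0) / 2), db.
  split; [lra | split; [lra | split; [auto | split; [lra |]]]].
  intros s hs.
  specialize (He1 s ltac:(rewrite Rabs_right; lra)). specialize (He2 s ltac:(rewrite Rabs_right; lra)).
  apply Rabs_def2 in He1. apply Rabs_def2 in He2.
  destruct (Rlt_dec 0 (w1 r0)) as [wp|wn].
  - rewrite Rabs_right in * by lra.
    rewrite (Rabs_right (w1 s)), (Rabs_right (w2 s)) by lra. split; [nra | split; split; nra].
  - rewrite Rabs_left in * by (destruct (Req_dec (w1 r0) 0); [rewrite H, Rabs_R0 in hw0 |]; lra).
    rewrite (Rabs_left (w1 s)), (Rabs_left (w2 s)) by lra. split; [nra | split; split; nra].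
Qed.

Lemma sols_agree_locally r0 : (1 <= N)%nat -> admissible g -> locally_lipschitz_on_pos g ->
  R1 <= r0 -> r0 < rs1 -> r0 < rs2 -> u1 r0 = u2 r0 -> v1 r0 = v2 r0 ->
  0 < u1 r0 -> ~ (u1 r0 = 1 /\ v1 r0 = 0) ->
  exists dl, 0 < dl /\ forall x, r0 <= x <= r0 + dl -> u1 x = u2 x /\ v1 x = v2 x.
Proof.
  intros hN Hg Hlip h0 hr1 hr2 hu hv hu0 hn.
  set (u0 := u1 r0) in *. assert (Hq := conj_exp_gt1 p hp).
  destruct (sol_right_continuous_u hR1 Hs1 r0 ltac:(lra) (u0/2) ltac:(lra)) as [e1 [he1 He1]].
  destruct (sol_right_continuous_u hR1 Hs2 r0 ltac:(lra) (u0/2) ltac:(lra)) as [e2 [he2 He2]].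
  rewrite <- hu in He2. fold u0 in He1, He2.
  set (da := Rmin (Rmin e1 e2) (Rmin ((rs1 - r0)/2) ((rs2 - r0)/2))).
  assert (hda1 : da <= e1) by (eapply Rle_trans; [apply Rmin_l | apply Rmin_l]).
  assert (hda2 : da <= e2) by (eapply Rle_trans; [apply Rmin_l | apply Rmin_r]).
  assert (hda3 : da <= (rs1 - r0)/2) by (eapply Rle_trans; [apply Rmin_r | apply Rmin_l]).
  assert (hda4 : da <= (rs2 - r0)/2) by (eapply Rle_trans; [apply Rmin_r | apply Rmin_r]).
  assert (hda : 0 < da) by (unfold da; repeat apply Rmin_pos; lra).
  (* both [u1] and [u2] stay in [[u0/2, 3 u0/2]], where [g] is Lipschitz *)
  destruct (Hlip (u0/2) (3 * u0/2) ltac:(lra) ltac:(lra)) as [L [hL HL]].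
  assert (HLu : forall s, r0 < s < r0 + da -> Rabs (g (u1 s) - g (u2 s)) <= L * Rabs (u1 s - u2 s)).
  { intros s hs. specialize (He1 s ltac:(lra)). specialize (He2 s ltac:(lra)).
    apply Rabs_def2 in He1. apply Rabs_def2 in He2. apply HL; split; lra. }
  assert (Hpin : exists c Wm db, 0 < c /\ 0 < Wm /\ 0 < db /\ db < da /\ pinched r0 db c Wm).
  { destruct (Req_dec (v1 r0) 0) as [hv0|hv0].
    - apply pinched_at_turning_point; auto; try lra; [apply Hg |]. fold u0.
      destruct Hg as [_ [_ [_ [Hneg Hpos]]]].
      assert (u0 <> 1) by (intro E; apply hn; split; auto).
      destruct (Rlt_dec u0 1); [assert (g u0 < 0) by (apply Hneg; lra) |
                                 assert (0 < g u0) by (apply Hpos; lra)]; lra.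
    - apply pinched_at_regular_point; auto; lra. }
  destruct Hpin as [c [Wm [db [hc [hW [hdb [hdba Hpin]]]]]]].
  destruct (contraction_rate_small (conj_exp p) L (Rpower c (conj_exp p - 2)) (Rpower Wm (conj_exp p - 2))
             Hq hL ltac:(left; apply Rpower_gt0) ltac:(left; apply Rpower_gt0) db hdb)
    as [dl [hdl [hdl2 Hdl]]].
  exists dl. split; auto.
  apply (sols_agree_of_pinched r0 dl L c Wm); auto; try lra.
  - intros s hs. apply HLu. lra.
  - intros s hs. apply Hpin. lra.
Qed.

End TwoSolutions.

Lemma sol_u_pos p N g R1 d u v rs : 1 < p -> 0 <= R1 -> admissible g -> 0 <= d < 1 ->
  is_solution_g p N g R1 d u v rs -> forall r, R1 <= r < rs -> 0 < u r.
Proof.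
  intros hp hR1 Hg hd Hs r hr. destruct (Rlt_dec 0 (u r)) as [|hn]; auto. exfalso.
  assert (HE := energy_le_init hp hR1 Hg Hs r hr). unfold energy in HE.
  rewrite (primitive_nonpos_arg g Hg (u r)) in HE by lra.
  assert (Hl := primitive_lt0 g Hg (1 - d) ltac:(lra)).
  assert (0 <= Rpower0 (Rabs (v r / r ^ (N - 1))) (conj_exp p)) by apply Rpower0_ge0.
  assert (0 < (p - 1) / p) by (apply Rdiv_lt_0_compat; lra). nra.
Qed.

Theorem solution_unique (p : R) (N : nat) (g : R -> R) (R1 d : R) (u1 v1 u2 v2 : R -> R) (rs1 rs2 K : R) :
  1 < p -> (1 <= N)%nat -> 0 <= R1 -> admissible g -> 0 < K ->
  (forall s, Rabs s <= 1 -> Rabs (g s) <= K * Rpower0 (Rabs s) (p - 1)) ->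
  locally_lipschitz_on_pos g -> 0 <= d <= 1 ->
  is_solution_g p N g R1 d u1 v1 rs1 -> is_solution_g p N g R1 d u2 v2 rs2 ->
  forall r, R1 <= r -> r < rs1 -> r < rs2 -> u1 r = u2 r /\ v1 r = v2 r.
Proof.
  intros hp hN hR1 Hg hK Hgrow Hlip hd Hs1 Hs2 r h1 h2 h3.
  assert (hrs1 := sol_interval Hs1). assert (hrs2 := sol_interval Hs2).
  destruct (Req_dec d 1) as [hd1|hd1].
  { destruct (sol_zero_if_d1 p N g R1 d u1 v1 rs1 hp hR1 Hs1 K hK Hgrow hd1 r ltac:(lra)).
    destruct (sol_zero_if_d1 p N g R1 d u2 v2 rs2 hp hR1 Hs2 K hK Hgrow hd1 r ltac:(lra)).
    split; congruence. }
  set (rs := Rmin rs1 rs2).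
  assert (hm1 : rs <= rs1) by apply Rmin_l. assert (hm2 : rs <= rs2) by apply Rmin_r.
  assert (Hr : R1 <= r < rs) by (unfold rs, Rmin; destruct (Rle_dec rs1 rs2); lra).
  assert (hrs : R1 < rs) by (unfold rs, Rmin; destruct (Rle_dec rs1 rs2); lra).
  clear h1 h2 h3. revert r Hr.
  apply (continuous_induction (fun x => u1 x = u2 x /\ v1 x = v2 x) R1 rs hrs).
  - rewrite (sol_u_init Hs1), (sol_u_init Hs2), (sol_v_init Hs1), (sol_v_init Hs2). auto.
  - intros r0 hr0 HQ. destruct (HQ r0 ltac:(lra)) as [hu hv].
    destruct (Classical_Prop.classic (u1 r0 = 1 /\ v1 r0 = 0)) as [[e1 e2]|hn].
    + exists 1. split; [lra |]. intros x hx hxc.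
      destruct (sol_stays_at_1 hp hR1 Hg Hs1 r0 ltac:(lra) e1 e2 x ltac:(lra)).
      destruct (sol_stays_at_1 hp hR1 Hg Hs2 r0 ltac:(lra) ltac:(lra) ltac:(lra) x ltac:(lra)).
      split; congruence.
    + destruct (sols_agree_locally p N g R1 d u1 v1 u2 v2 rs1 rs2 hp hR1 Hs1 Hs2 r0
                  hN Hg Hlip ltac:(lra) ltac:(lra) ltac:(lra) hu hv
                  (sol_u_pos p N g R1 d u1 v1 rs1 hp hR1 Hg ltac:(lra) Hs1 r0 ltac:(lra)) hn)
        as [dl [hdl Hdl]].
      exists dl. split; auto.
  - intros r0 hr0 HQ. split.
    + assert (H := continuous_zero_of_zero_on_left (fun y => u1 y - u2 y) R1 r0 ltac:(lra)).
      cbv beta in H. assert (u1 r0 - u2 r0 = 0); [| lra]. apply H.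
      * apply continuous_Rminus; [apply (sol_continuous_u hR1 Hs1) | apply (sol_continuous_u hR1 Hs2)]; lra.
      * intros y hy. destruct (HQ y hy). lra.
    + assert (H := continuous_zero_of_zero_on_left (fun y => v1 y - v2 y) R1 r0 ltac:(lra)).
      cbv beta in H. assert (v1 r0 - v2 r0 = 0); [| lra]. apply H.
      * apply continuous_Rminus; [apply (sol_continuous_v hR1 Hs1) | apply (sol_continuous_v hR1 Hs2)]; lra.
      * intros y hy. destruct (HQ y hy). lra.
Qed.

(** * The nonlinearity [fhat f] *)

Section Fhat.
Variable f : R -> R.
Hypothesis Hreg : f_reg f.
Hypothesis Heq : f_eq f.

Lemma fhat_nonneg s : 0 <= s -> fhat f s = f s.
Proof. intros h. unfold fhat. destruct (Rle_dec 0 s); [auto | lra]. Qed.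

Lemma fhat_neg s : s < 0 -> fhat f s = 0.
Proof. intros h. unfold fhat. destruct (Rle_dec 0 s); [lra | auto]. Qed.

Lemma continuous_f_pos s : 0 < s -> continuous f s.
Proof. intros h. destruct (proj2 Hreg s h) as [[l Hl] _]. apply (is_derive_continuous f s l Hl). Qed.

Lemma continuous_fhat s : continuous (fhat f) s.
Proof.
  destruct (Rtotal_order s 0) as [h|[->|h]].
  - apply (continuous_ext_loc _ (fun _ => 0)); [| apply continuous_const].
    apply (filter_imp (fun y => y < 0)); [| apply locally_lt; auto].
    intros y hy. rewrite fhat_neg; auto.
  - apply continuous_of_eps_delta. intros eps he.
    destruct (right_continuous_of_filterlim f 0 (proj1 Hreg) eps he) as [dl [hdl Hdl]].
    exists dl. split; auto. intros y hy. rewrite (fhat_nonneg 0), (proj1 Heq) by lra.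
    destruct (Rlt_dec y 0).
    + rewrite fhat_neg, Rminus_0_r, Rabs_R0; auto.
    + rewrite fhat_nonneg, <- (proj1 Heq) by lra. apply Hdl.
      rewrite Rminus_0_r in hy. apply Rabs_def2 in hy. lra.
  - apply (continuous_ext_loc _ f); [| apply continuous_f_pos; auto].
    apply (filter_imp (fun y => 0 < y)); [| apply locally_gt; auto].
    intros y hy. rewrite fhat_nonneg; lra.
Qed.

Lemma admissible_fhat : admissible (fhat f).
Proof.
  destruct Heq as [e0 [e1 [Hn Hp]]].
  split; [apply continuous_fhat | split; [| split; [| split]]].
  - intros s hs. destruct (Req_dec s 0) as [->|]; [rewrite fhat_nonneg; lra | apply fhat_neg; lra].
  - rewrite fhat_nonneg; lra.
  - intros s hs. rewrite fhat_nonneg by lra. apply Hn; auto.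
  - intros s hs. rewrite fhat_nonneg by lra. apply Hp; auto.
Qed.

Lemma fhat_locally_lipschitz : locally_lipschitz_on_pos (fhat f).
Proof.
  intros a b ha hab. destruct Hreg as [_ Hd].
  destruct (continuity_ab_maj (fun s => Rabs (Derive f s)) a b hab) as [m [Hm hm]].
  { intros c hc. apply continuity_pt_filterlim, continuous_Rabs_comp, Hd. lra. }
  exists (Rabs (Derive f m)). split; [apply Rabs_pos |].
  intros x y hx hy. rewrite !fhat_nonneg by lra.
  destruct (MVT_gen f y x (Derive f)) as [c [hc Hc]].
  { intros z hz. apply Derive_correct, Hd. unfold Rmin, Rmax in hz. destruct (Rle_dec y x); lra. }
  { intros z hz. apply continuity_pt_filterlim, continuous_f_pos.
    unfold Rmin, Rmax in hz. destruct (Rle_dec y x); lra. }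
  rewrite Hc, Rabs_mult. apply Rmult_le_compat_r; [apply Rabs_pos |]. apply Hm.
  unfold Rmin, Rmax in hc. destruct (Rle_dec y x); lra.
Qed.

Lemma fhat_bounded a b : a <= b -> exists B, 0 <= B /\ forall s, a <= s <= b -> Rabs (fhat f s) <= B.
Proof.
  intros hab. destruct (continuity_ab_maj (fun s => Rabs (fhat f s)) a b hab) as [m [Hm hm]].
  { intros c hc. apply continuity_pt_filterlim, continuous_Rabs_comp, continuous_fhat. }
  exists (Rabs (fhat f m)). split; [apply Rabs_pos | auto].
Qed.

(** [(f_0)] bounds [f s / s^(p-1)] near [0], continuity bounds it away from [0]. *)
Lemma fhat_growth_at_0 p : 1 < p -> f_0 p f ->
  exists K, 0 < K /\ forall s, Rabs s <= 1 -> Rabs (fhat f s) <= K * Rpower0 (Rabs s) (p - 1).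
Proof.
  intros hp [C0 [hC0 Hlim]].
  destruct (proj1 (filterlim_locally _ (- C0)) Hlim (mkposreal 1 Rlt_0_1)) as [[e he] He].
  simpl in He. set (eta := Rmin (e / 2) 1).
  assert (heta : 0 < eta) by (apply Rmin_pos; lra).
  assert (heta1 : eta <= e / 2) by apply Rmin_l. assert (heta2 : eta <= 1) by apply Rmin_r.
  destruct (fhat_bounded 0 1 ltac:(lra)) as [B [hB HB]].
  assert (hPe : 0 < Rpower eta (p - 1)) by apply Rpower_gt0.
  assert (hBe : 0 <= B / Rpower eta (p - 1)) by (apply Rdiv_le_0_compat; lra).
  exists (C0 + 1 + B / Rpower eta (p - 1)). split; [lra |].
  intros s hs. destruct (Rle_dec s 0) as [hs0|hs0].
  { assert (0 <= Rpower0 (Rabs s) (p - 1)) by apply Rpower0_ge0.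
    destruct (Req_dec s 0) as [->|].
    - rewrite fhat_nonneg, (proj1 Heq), Rabs_R0, Rpower0_0 by lra. lra.
    - rewrite fhat_neg, Rabs_R0 by lra. nra. }
  rewrite (Rabs_right s) in hs |- * by lra. rewrite Rpower0_pos, fhat_nonneg by lra.
  assert (hPs : 0 < Rpower s (p - 1)) by apply Rpower_gt0.
  destruct (Rlt_dec s eta) as [hse|hse].
  - assert (Hb : ball 0 e s) by (apply ball_Rabs; rewrite Rminus_0_r, Rabs_right; lra).
    assert (He' : Rabs (f s / Rpower s (p - 1) - - C0) < 1) by exact (He s Hb ltac:(lra)).
    apply Rabs_def2 in He'.
    assert (HH : Rabs (f s / Rpower s (p - 1)) <= C0 + 1) by (apply Rabs_le; lra).
    unfold Rdiv in HH. rewrite Rabs_mult, Rabs_inv, (Rabs_right (Rpower s (p - 1))) in HH by lra.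
    assert (Rabs (f s) <= (C0 + 1) * Rpower s (p - 1)).
    { apply (Rmult_le_reg_r (/ Rpower s (p - 1))); [apply Rinv_0_lt_compat; auto |].
      rewrite Rmult_assoc, Rinv_r, Rmult_1_r by lra. auto. }
    nra.
  - assert (Rpower eta (p - 1) <= Rpower s (p - 1)) by (apply Rle_Rpower_l; lra).
    specialize (HB s ltac:(lra)). rewrite fhat_nonneg in HB by lra.
    assert (B <= B / Rpower eta (p - 1) * Rpower s (p - 1)).
    { unfold Rdiv. replace B with (B * / Rpower eta (p - 1) * Rpower eta (p - 1)) at 1 by (field; lra).
      apply Rmult_le_compat_l; [apply Rmult_le_pos; [auto | left; apply Rinv_0_lt_compat; auto] | auto]. }
    nra.
Qed.

End Fhat.

(** * Sequences and the Arzela-Ascoli theorem *)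

Lemma Un_cv_bound (a : nat -> R) l C : Un_cv a l -> (forall n, Rabs (a n) <= C) -> Rabs l <= C.
Proof.
  intros Hc HC. destruct (Rle_dec (Rabs l) C) as [|hn]; auto. exfalso.
  destruct (Hc (Rabs l - C) ltac:(lra)) as [N HN]. specialize (HN N (le_n N)). specialize (HC N).
  unfold Rdist in HN.
  assert (Rabs l <= Rabs (a N) + Rabs (a N - l)).
  { replace l with (a N - (a N - l)) at 1 by ring.
    eapply Rle_trans; [apply Rabs_triang | rewrite Rabs_Ropp; lra]. }
  lra.
Qed.

Lemma Un_cv_const_eq (a : nat -> R) l c : Un_cv a l -> (forall n, a n = c) -> l = c.
Proof.
  intros Hc Ha. apply (UL_sequence a); auto.
  intros eps he. exists O. intros n _. unfold Rdist. rewrite Ha, Rminus_eq_0, Rabs_R0. lra.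
Qed.

Lemma Un_cv_dist_le (U : nat -> R -> R) (u : R -> R) x y K :
  Un_cv (fun n => U n x) (u x) -> Un_cv (fun n => U n y) (u y) ->
  (forall n, Rabs (U n x - U n y) <= K) -> Rabs (u x - u y) <= K.
Proof.
  intros Hx Hy HK. apply (Un_cv_bound (fun n => U n x - U n y)); auto.
  apply CV_minus; auto.
Qed.

Lemma inv_INR_succ_small eps : 0 < eps ->
  exists n0 : nat, forall n, (n0 <= n)%nat -> / (INR n + 1) < eps.
Proof.
  intros he. destruct (archimed (/ eps)) as [hA _].
  exists (Z.to_nat (up (/ eps))). intros n hn.
  assert (0 < / eps) by (apply Rinv_0_lt_compat; auto).
  assert (/ eps < INR n + 1).
  { apply le_INR in hn. rewrite INR_IZR_INZ, Z2Nat.id in hn by (apply le_IZR; lra). lra. }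
  rewrite <- (Rinv_inv eps). apply Rinv_lt_contravar; [apply Rmult_lt_0_compat |]; lra.
Qed.

Lemma exists_fine_mesh c eps : 0 < eps -> 0 <= c -> exists K : nat, (0 < K)%nat /\ c / INR K <= eps.
Proof.
  intros he hc. destruct (inv_INR_succ_small (eps / (c + 1))) as [K0 HK0]; [apply Rdiv_lt_0_compat; lra |].
  exists (S K0). split; [lia |]. specialize (HK0 K0 (le_n K0)). rewrite S_INR.
  assert (0 < INR K0 + 1) by (assert (0 <= INR K0) by apply pos_INR; lra).
  apply (Rmult_lt_compat_l (c + 1)) in HK0; [| lra].
  replace ((c + 1) * (eps / (c + 1))) with eps in HK0 by (field; lra).
  unfold Rdiv. apply Rle_trans with ((c + 1) * / (INR K0 + 1)); [| lra].
  apply Rmult_le_compat_r; [left; apply Rinv_0_lt_compat |]; lra.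
Qed.

Definition extraction (s : nat -> nat) := forall n, (s n < s (S n))%nat.

Lemma extraction_ge s : extraction s -> forall n, (n <= s n)%nat.
Proof. intros H n. induction n; [lia |]. specialize (H n). lia. Qed.

Lemma extraction_le s : extraction s -> forall n m, (n <= m)%nat -> (s n <= s m)%nat.
Proof. intros H n m hnm. induction hnm; [lia |]. specialize (H m). lia. Qed.

Lemma extraction_comp s t : extraction s -> extraction t -> extraction (fun n => s (t n)).
Proof.
  intros Hs Ht n. assert (H := extraction_le s Hs (S (t n)) (t (S n)) (Ht n)).
  specialize (Hs (t n)). lia.
Qed.

Lemma extraction_id : extraction (fun n => n).
Proof. intros n; lia. Qed.

Lemma Un_cv_extraction u l s : extraction s -> Un_cv u l -> Un_cv (fun n => u (s n)) l.
Proof.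
  intros Hs H eps he. destruct (H eps he) as [N HN]. exists N. intros n hn. apply HN.
  assert (H1 := extraction_ge s Hs n). lia.
Qed.

(** Recursive choice of indices [s n >= s (n-1) + 1] with [x (s n)] in [B(l, 1/(n+1))]. *)
Lemma Bolzano_Weierstrass_extraction (x : nat -> R) B : (forall n, Rabs (x n) <= B) ->
  exists s l, extraction s /\ Un_cv (fun n => x (s n)) l.
Proof.
  intros HB. destruct (Bolzano_Weierstrass x (fun c => - B <= c <= B) (compact_P3 (- B) B)) as [l Hl].
  { intros n. apply Rabs_le_between, HB. }
  assert (Hpick : forall m k : nat, exists p, (m <= p)%nat /\ Rabs (x p - l) < / (INR k + 1)).
  { intros m k. assert (hk : 0 < / (INR k + 1)) by (apply Rinv_0_lt_compat; assert (0 <= INR k) by apply pos_INR; lra).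
    destruct (Hl (disc l (mkposreal _ hk)) m) as [p [hp Hp]].
    { exists (mkposreal _ hk). intros y hy. auto. }
    exists p. split; auto. }
  set (pick := fun m k => proj1_sig (constructive_indefinite_description _ (Hpick m k))).
  assert (Hpk : forall m k, (m <= pick m k)%nat /\ Rabs (x (pick m k) - l) < / (INR k + 1)).
  { intros m k. unfold pick. destruct (constructive_indefinite_description _ (Hpick m k)) as [p Hp]. auto. }
  set (s := fix s (n : nat) : nat := match n with O => pick O O | S n' => pick (S (s n')) (S n') end).
  exists s, l. split.
  - intros n. simpl. destruct (Hpk (S (s n)) (S n)). lia.
  - intros eps he. destruct (inv_INR_succ_small eps he) as [N HN]. exists N. intros n hn.
    apply Rlt_trans with (/ (INR n + 1)); [| apply HN; lia].
    destruct n; [apply (Hpk O O) | apply (Hpk (S (s n)) (S n))].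
Qed.

Lemma nearest_nat (n : nat) (y : R) : 0 <= y <= INR n ->
  exists i, (i <= n)%nat /\ Rabs (y - INR i) <= 1.
Proof.
  induction n as [|n IH]; intros hy.
  - exists O. split; [lia |]. simpl in *. rewrite Rminus_0_r, Rabs_right; lra.
  - rewrite S_INR in hy. destruct (Rle_dec y (INR n)).
    + destruct (IH ltac:(lra)) as [i [hi Hi]]. exists i. split; auto.
    + exists (S n). split; [lia |]. rewrite S_INR, Rabs_left1 by lra. lra.
Qed.

Lemma grid_point_near a b (K : nat) x : (0 < K)%nat -> a <= x <= b ->
  exists i, (i <= K)%nat /\ Rabs (x - (a + (b - a) * INR i / INR K)) <= (b - a) / INR K.
Proof.
  intros hK hx. assert (hKp : 0 < INR K) by (apply lt_0_INR; auto).
  destruct (Req_dec a b) as [E|hne].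
  { exists O. split; [lia |]. subst. replace x with b by lra.
    replace (b + (b - b) * INR 0 / INR K) with b by (field; lra).
    rewrite Rminus_eq_0, Rabs_R0. right. field. lra. }
  set (y := (x - a) / (b - a) * INR K).
  assert (hy : 0 <= y <= INR K).
  { unfold y. split; [apply Rmult_le_pos; [apply Rdiv_le_0_compat |]; lra |].
    rewrite <- (Rmult_1_l (INR K)) at 2. apply Rmult_le_compat_r; [lra |].
    apply (Rmult_le_reg_r (b - a)); [lra |]. unfold Rdiv. rewrite Rmult_assoc, Rinv_l by lra. lra. }
  destruct (nearest_nat K y hy) as [i [hi Hi]]. exists i. split; auto.
  replace (x - (a + (b - a) * INR i / INR K)) with ((b - a) / INR K * (y - INR i))
    by (unfold y; field; split; lra).
  rewrite Rabs_mult, (Rabs_right ((b - a) / INR K)) by (apply Rle_ge, Rdiv_le_0_compat; lra).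
  rewrite <- (Rmult_1_r ((b - a) / INR K)) at 2.
  apply Rmult_le_compat_l; [apply Rdiv_le_0_compat; lra | auto].
Qed.

Definition unif_cv (Y : nat -> R -> R) (z : R -> R) (S : R -> Prop) :=
  forall eps, 0 < eps -> exists N, forall n, (N <= n)%nat -> forall y, S y -> Rabs (Y n y - z y) <= eps.

(** Arzela-Ascoli for equibounded, equi-Lipschitz sequences on [[a, b]]: a diagonal
    extraction whose [m]-th stage is uniformly [1/(m+1)]-Cauchy. *)
Section ArzelaAscoli.
Variables (h : nat -> R -> R) (a b B L : R).
Hypothesis hab : a <= b.
Hypothesis hL : 0 <= L.
Hypothesis HB : forall n x, a <= x <= b -> Rabs (h n x) <= B.
Hypothesis HL : forall n x y, a <= x <= b -> a <= y <= b -> Rabs (h n x - h n y) <= L * Rabs (x - y).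

Lemma Un_cv_on_finite (pts : list R) : (forall x, In x pts -> a <= x <= b) -> forall s0 : nat -> nat,
  exists s, extraction s /\ forall x, In x pts -> exists l, Un_cv (fun n => h (s0 (s n)) x) l.
Proof.
  induction pts as [|x pts IH]; intros Hp s0.
  - exists (fun n => n). split; [apply extraction_id | intros x []].
  - destruct (IH ltac:(intros; apply Hp; right; auto) s0) as [s1 [Hs1 Hc1]].
    destruct (Bolzano_Weierstrass_extraction (fun n => h (s0 (s1 n)) x) B) as [s2 [l [Hs2 Hc2]]].
    { intros n. apply HB, Hp. left; auto. }
    exists (fun n => s1 (s2 n)). split; [apply extraction_comp; auto |].
    intros y [<-|hy]; [exists l; auto |].
    destruct (Hc1 y hy) as [l' Hl']. exists l'.
    apply (Un_cv_extraction (fun n => h (s0 (s1 n)) y) l' s2 Hs2 Hl').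
Qed.

Definition unif_cauchy (k : nat -> R -> R) (eps : R) := exists N, forall n m, (N <= n)%nat -> (N <= m)%nat ->
  forall x, a <= x <= b -> Rabs (k n x - k m x) <= eps.

Lemma cauchy_on_finite (pts : list R) (k : nat -> R -> R) eps : 0 < eps ->
  (forall x, In x pts -> exists l, Un_cv (fun n => k n x) l) ->
  exists N, forall x, In x pts -> forall n m, (N <= n)%nat -> (N <= m)%nat -> Rabs (k n x - k m x) < eps.
Proof.
  intros he. induction pts as [|x pts IH]; intros Hc; [exists O; intros x [] |].
  destruct IH as [N1 HN1]; [intros; apply Hc; right; auto |].
  destruct (Hc x (or_introl eq_refl)) as [l Hl]. destruct (Hl (eps/2) ltac:(lra)) as [N2 HN2].
  exists (max N1 N2). intros y [<-|hy] n m hn hm; [| apply HN1; auto; lia].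
  assert (H2 := HN2 n ltac:(lia)). assert (H3 := HN2 m ltac:(lia)). unfold Rdist in *.
  replace (k n x - k m x) with ((k n x - l) - (k m x - l)) by ring.
  eapply Rle_lt_trans; [apply Rabs_triang | rewrite Rabs_Ropp; lra].
Qed.

(** [eps/3]-Cauchy on a grid of mesh [(b - a) / K] with [L (b - a) / K <= eps/3] gives [eps]-Cauchy. *)
Lemma unif_cauchy_extraction eps : 0 < eps -> forall s0 : nat -> nat,
  exists s, extraction s /\ unif_cauchy (fun n => h (s0 (s n))) eps.
Proof.
  intros he s0.
  destruct (exists_fine_mesh (L * (b - a)) (eps / 3)) as [K [hK HK]]; [lra | apply Rmult_le_pos; lra |].
  assert (hKp : 0 < INR K) by (apply lt_0_INR; auto).
  set (pts := map (fun i => a + (b - a) * INR i / INR K) (seq 0 (S K))).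
  assert (Hpts : forall x, In x pts -> a <= x <= b).
  { intros x hx. apply in_map_iff in hx. destruct hx as [i [<- hi]].
    apply in_seq in hi. assert (INR i <= INR K) by (apply le_INR; lia).
    assert (0 <= INR i) by apply pos_INR.
    assert (0 <= (b - a) * INR i / INR K <= b - a); [| lra].
    split; [apply Rdiv_le_0_compat; [apply Rmult_le_pos |]; lra |].
    apply (Rmult_le_reg_r (INR K)); auto. unfold Rdiv. rewrite Rmult_assoc, Rinv_l, Rmult_1_r by lra. nra. }
  destruct (Un_cv_on_finite pts Hpts s0) as [s [Hs Hc]].
  destruct (cauchy_on_finite pts (fun n x => h (s0 (s n)) x) (eps / 3) ltac:(lra) Hc) as [N HN].
  exists s. split; auto. exists N. intros n m hn hm x hx.
  destruct (grid_point_near a b K x hK hx) as [i [hi Hi]].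
  set (xi := a + (b - a) * INR i / INR K) in *.
  assert (Hin : In xi pts) by (apply (in_map (fun i => a + (b - a) * INR i / INR K)), in_seq; lia).
  assert (Hxi := Hpts xi Hin).
  assert (H1 := HN xi Hin n m hn hm). simpl in H1.
  assert (H2 := HL (s0 (s n)) x xi hx Hxi). assert (H3 := HL (s0 (s m)) x xi hx Hxi).
  assert (HLe : L * Rabs (x - xi) <= eps / 3).
  { eapply Rle_trans; [apply Rmult_le_compat_l; [auto | apply Hi] |].
    replace (L * ((b - a) / INR K)) with (L * (b - a) / INR K) by (field; lra). auto. }
  replace (h (s0 (s n)) x - h (s0 (s m)) x)
    with ((h (s0 (s n)) x - h (s0 (s n)) xi) + (h (s0 (s n)) xi - h (s0 (s m)) xi)
          - (h (s0 (s m)) x - h (s0 (s m)) xi)) by ring.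
  eapply Rle_trans; [apply Rabs_triang |]. rewrite Rabs_Ropp.
  assert (H4 := Rabs_triang (h (s0 (s n)) x - h (s0 (s n)) xi) (h (s0 (s n)) xi - h (s0 (s m)) xi)).
  lra.
Qed.

Definition stage_extraction (m : nat) (s0 : nat -> nat) : nat -> nat :=
  epsilon (inhabits (fun n => n))
    (fun s => extraction s /\ unif_cauchy (fun n => h (s0 (s n))) (/ (INR m + 1))).

Lemma stage_extraction_spec m s0 :
  extraction (stage_extraction m s0) /\
  unif_cauchy (fun n => h (s0 (stage_extraction m s0 n))) (/ (INR m + 1)).
Proof.
  unfold stage_extraction.
  apply (epsilon_spec (inhabits (fun n => n))
           (fun s => extraction s /\ unif_cauchy (fun n => h (s0 (s n))) (/ (INR m + 1)))).
  apply unif_cauchy_extraction, Rinv_0_lt_compat. assert (0 <= INR m) by apply pos_INR. lra.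
Qed.

Fixpoint diag_stage (m : nat) : nat -> nat :=
  match m with
  | O => stage_extraction O (fun n => n)
  | S m' => fun n => diag_stage m' (stage_extraction (S m') (diag_stage m') n)
  end.

Lemma diag_stage_extraction m : extraction (diag_stage m).
Proof.
  induction m; simpl; [apply (stage_extraction_spec O (fun n => n)) |].
  apply extraction_comp; auto. apply stage_extraction_spec.
Qed.

Lemma diag_stage_unif_cauchy m : unif_cauchy (fun n => h (diag_stage m n)) (/ (INR m + 1)).
Proof.
  destruct m; simpl; [apply (stage_extraction_spec O (fun n => n)) |].
  apply (stage_extraction_spec (S m) (diag_stage m)).
Qed.

Lemma diag_stage_tail m dd n : exists k, (n <= k)%nat /\ diag_stage (m + dd) n = diag_stage m k.
Proof.
  revert n. induction dd; intros n; [exists n; rewrite Nat.add_0_r; split; auto |].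
  rewrite Nat.add_succ_r. simpl.
  destruct (IHdd (stage_extraction (S (m + dd)) (diag_stage (m + dd)) n)) as [k [hk Hk]].
  exists k. split; auto.
  assert (H := extraction_ge _ (proj1 (stage_extraction_spec (S (m + dd)) (diag_stage (m + dd)))) n).
  lia.
Qed.

Definition diagonal (n : nat) := diag_stage n n.

Lemma diagonal_extraction : extraction diagonal.
Proof.
  intros n. unfold diagonal. simpl. assert (H := proj1 (stage_extraction_spec (S n) (diag_stage n))).
  assert (H1 := extraction_ge _ H (S n)).
  assert (H2 := extraction_le _ (diag_stage_extraction n) (S n) _ H1).
  assert (H3 := diag_stage_extraction n n). lia.
Qed.

Lemma diagonal_unif_cauchy m : unif_cauchy (fun n => h (diagonal n)) (/ (INR m + 1)).
Proof.
  destruct (diag_stage_unif_cauchy m) as [N HN]. exists (max m N). intros n n' hn hn' x hx.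
  unfold diagonal.
  destruct (diag_stage_tail m (n - m) n) as [k [hk Hk]].
  destruct (diag_stage_tail m (n' - m) n') as [k' [hk' Hk']].
  replace (m + (n - m))%nat with n in Hk by lia. replace (m + (n' - m))%nat with n' in Hk' by lia.
  rewrite Hk, Hk'. apply HN; auto; lia.
Qed.

Definition diagonal_limit (x : R) : R :=
  epsilon (inhabits 0) (fun l => Un_cv (fun n => h (diagonal n) x) l).

Lemma diagonal_limit_spec x : a <= x <= b -> Un_cv (fun n => h (diagonal n) x) (diagonal_limit x).
Proof.
  intros hx. unfold diagonal_limit.
  apply (epsilon_spec (inhabits 0) (fun l => Un_cv (fun n => h (diagonal n) x) l)).
  assert (Hc : Cauchy_crit (fun n => h (diagonal n) x)).
  { intros eps he. destruct (inv_INR_succ_small eps he) as [m Hm].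
    destruct (diagonal_unif_cauchy m) as [N HN]. exists N. intros n n' hn hn'. unfold Rdist.
    eapply Rle_lt_trans; [apply HN; auto | apply Hm; lia]. }
  destruct (Rcomplete.R_complete _ Hc) as [l Hl]. exists l. exact Hl.
Qed.

Theorem Arzela_Ascoli : exists (s : nat -> nat) (ph : R -> R),
  extraction s /\ unif_cv (fun n => h (s n)) ph (fun x => a <= x <= b).
Proof.
  exists diagonal, diagonal_limit. split; [apply diagonal_extraction |].
  intros eps he. destruct (inv_INR_succ_small eps he) as [m Hm].
  destruct (diagonal_unif_cauchy m) as [N HN]. exists N. intros n hn x hx.
  apply Rle_trans with (/ (INR m + 1)); [| left; apply Hm; lia].
  apply (Un_cv_bound (fun k => h (diagonal n) x - h (diagonal (k + N)%nat) x)).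
  - apply CV_minus; [intros e he'; exists O; intros; unfold Rdist; rewrite Rminus_eq_0, Rabs_R0; lra |].
    apply (Un_cv_extraction (fun k => h (diagonal k) x) _ (fun k => (k + N)%nat));
      [intros k; lia | apply diagonal_limit_spec, hx].
  - intros k. apply HN; [lia | lia | auto].
Qed.

End ArzelaAscoli.

Lemma unif_cv_extraction (Y : nat -> R -> R) z S s : extraction s -> unif_cv Y z S ->
  unif_cv (fun n => Y (s n)) z S.
Proof.
  intros Hs H eps he. destruct (H eps he) as [N HN]. exists N. intros n hn. apply HN.
  assert (H1 := extraction_ge s Hs n). lia.
Qed.

Lemma Arzela_Ascoli2 (U V : nat -> R -> R) a b BU BV LU LV : a <= b -> 0 <= LU -> 0 <= LV ->
  (forall n x, a <= x <= b -> Rabs (U n x) <= BU) ->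
  (forall n x, a <= x <= b -> Rabs (V n x) <= BV) ->
  (forall n x y, a <= x <= b -> a <= y <= b -> Rabs (U n x - U n y) <= LU * Rabs (x - y)) ->
  (forall n x y, a <= x <= b -> a <= y <= b -> Rabs (V n x - V n y) <= LV * Rabs (x - y)) ->
  exists s u v, extraction s /\ unif_cv (fun n => U (s n)) u (fun x => a <= x <= b) /\
    unif_cv (fun n => V (s n)) v (fun x => a <= x <= b).
Proof.
  intros hab hLU hLV HBU HBV HLU HLV.
  destruct (Arzela_Ascoli U a b BU LU hab hLU HBU HLU) as [s1 [u [Hs1 Hu]]].
  destruct (Arzela_Ascoli (fun n => V (s1 n)) a b BV LV hab hLV) as [s2 [v [Hs2 Hv]]]; auto.
  exists (fun n => s1 (s2 n)), u, v.
  split; [apply extraction_comp; auto |].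
  split; [apply (unif_cv_extraction (fun n => U (s1 n))); auto | auto].
Qed.

Lemma unif_cv_Un_cv (Y : nat -> R -> R) z (S : R -> Prop) y :
  unif_cv Y z S -> S y -> Un_cv (fun n => Y n y) (z y).
Proof.
  intros H hy eps he. destruct (H (eps/2) ltac:(lra)) as [N HN]. exists N. intros n hn.
  specialize (HN n hn y hy). unfold Rdist. lra.
Qed.

Lemma unif_cv_bound (Y : nat -> R -> R) z (S : R -> Prop) C :
  unif_cv Y z S -> (forall n y, S y -> Rabs (Y n y) <= C) -> forall y, S y -> Rabs (z y) <= C.
Proof.
  intros HY HC y hy. apply (Un_cv_bound _ _ _ (unif_cv_Un_cv Y z S y HY hy)). intros n. apply HC, hy.
Qed.

Lemma unif_cv_sub (Y : nat -> R -> R) (z : R -> R) (S S' : R -> Prop) :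
  (forall y, S' y -> S y) -> unif_cv Y z S -> unif_cv Y z S'.
Proof. intros HS H eps he. destruct (H eps he) as [N HN]. exists N. intros n hn y hy. apply HN; auto. Qed.

Lemma unif_cv_ext (Y Y' : nat -> R -> R) (z z' : R -> R) (S : R -> Prop) :
  (forall n y, S y -> Y n y = Y' n y) -> (forall y, S y -> z y = z' y) -> unif_cv Y z S -> unif_cv Y' z' S.
Proof.
  intros H1 H2 H eps he. destruct (H eps he) as [N HN]. exists N. intros n hn y hy.
  rewrite <- H1, <- H2 by auto. auto.
Qed.

Lemma unif_cv_comp (F : R -> R) (Y : nat -> R -> R) (z : R -> R) (S : R -> Prop) M :
  (forall x, continuous F x) -> unif_cv Y z S -> (forall y, S y -> Rabs (z y) <= M) ->
  unif_cv (fun n y => F (Y n y)) (fun y => F (z y)) S.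
Proof.
  intros HF HY HM eps he.
  destruct (Heine F (fun c => - (Rabs M + 1) <= c <= Rabs M + 1) (compact_P3 _ _)) with (mkposreal eps he)
    as [[dl hdl] Hdl]; [intros x _; apply continuity_pt_filterlim, HF |].
  destruct (HY (Rmin (dl / 2) (1/2)) ltac:(apply Rmin_pos; lra)) as [N HN].
  exists N. intros n hn y hy. specialize (HN n hn y hy). specialize (HM y hy).
  assert (h1 := Rmin_l (dl/2) (1/2)). assert (h2 := Rmin_r (dl/2) (1/2)).
  assert (hM := Rle_abs M).
  left. apply (Hdl (Y n y) (z y)); simpl; [| apply Rabs_le_between; lra | lra].
  apply Rabs_le_between. replace (Y n y) with ((Y n y - z y) + z y) by ring.
  eapply Rle_trans; [apply Rabs_triang | lra].
Qed.

Lemma unif_cv_scale (Y : nat -> R -> R) (z k : R -> R) (S : R -> Prop) C :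
  0 < C -> unif_cv Y z S -> (forall y, S y -> Rabs (k y) <= C) ->
  unif_cv (fun n y => k y * Y n y) (fun y => k y * z y) S.
Proof.
  intros hC HY Hk eps he. destruct (HY (eps / C) ltac:(apply Rdiv_lt_0_compat; lra)) as [N HN].
  exists N. intros n hn y hy. rewrite <- Rmult_minus_distr_l, Rabs_mult.
  specialize (HN n hn y hy). specialize (Hk y hy).
  apply Rle_trans with (C * (eps / C)); [apply Rmult_le_compat; auto; apply Rabs_pos |].
  right; field; lra.
Qed.

(** * Existence *)

Lemma is_derive_of_unif_cv (G Hd : nat -> R -> R) (gl hl : R -> R) (x0 c1 c2 : R) :
  c1 < x0 < c2 -> (forall n y, c1 < y < c2 -> is_derive (G n) y (Hd n y)) ->
  (forall y, c1 < y < c2 -> Un_cv (fun n => G n y) (gl y)) ->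
  unif_cv Hd hl (fun y => c1 < y < c2) -> continuous hl x0 -> is_derive gl x0 (hl x0).
Proof.
  intros hx HG Hc Hu Hh. apply is_derive_Reals. intros eps he.
  destruct (continuous_eps_delta hl x0 Hh (eps/4) ltac:(lra)) as [dc [hdc Hdc]].
  set (dl := Rmin dc (Rmin (x0 - c1) (c2 - x0))).
  assert (h1 : dl <= dc) by apply Rmin_l.
  assert (h2 : dl <= x0 - c1) by (eapply Rle_trans; [apply Rmin_r | apply Rmin_l]).
  assert (h3 : dl <= c2 - x0) by (eapply Rle_trans; [apply Rmin_r | apply Rmin_r]).
  assert (hdl : 0 < dl) by (unfold dl; repeat apply Rmin_pos; lra).
  exists (mkposreal dl hdl). intros h hh0 hh. simpl in hh.
  assert (hha : 0 < Rabs h) by (apply Rabs_pos_lt; auto).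
  apply Rabs_def2 in hh as hh'.
  set (eta := eps / 8 * Rabs h).
  assert (heta : 0 < eta) by (unfold eta; apply Rmult_lt_0_compat; lra).
  destruct (Hc (x0 + h) ltac:(lra) eta heta) as [N1 HN1].
  destruct (Hc x0 ltac:(lra) eta heta) as [N2 HN2].
  destruct (Hu (eps/8) ltac:(lra)) as [N3 HN3].
  set (n := max N1 (max N2 N3)).
  specialize (HN1 n ltac:(lia)). specialize (HN2 n ltac:(lia)). unfold Rdist in HN1, HN2.
  destruct (MVT_gen (G n) x0 (x0 + h) (Hd n)) as [c [hc Hcc]].
  { intros y hy. apply HG. unfold Rmin, Rmax in hy. destruct (Rle_dec x0 (x0 + h)); lra. }
  { intros y hy. apply continuity_pt_filterlim, (is_derive_continuous _ _ (Hd n y)), HG.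
    unfold Rmin, Rmax in hy. destruct (Rle_dec x0 (x0 + h)); lra. }
  assert (hc' : c1 < c < c2 /\ Rabs (c - x0) < dc).
  { unfold Rmin, Rmax in hc. destruct (Rle_dec x0 (x0 + h)); split; try lra; apply Rabs_def1; lra. }
  specialize (HN3 n ltac:(lia) c ltac:(lra)). specialize (Hdc c ltac:(lra)).
  replace (x0 + h - x0) with h in Hcc by ring.
  (* split the difference quotient at the MVT point [c] of [G n] *)
  replace ((gl (x0 + h) - gl x0) / h - hl x0) with
    (((gl (x0 + h) - G n (x0 + h)) - (gl x0 - G n x0)) / h + (Hd n c - hl c) + (hl c - hl x0))
    by (replace (Hd n c) with ((G n (x0 + h) - G n x0) / h) by (rewrite Hcc; field; auto); field; auto).
  eapply Rle_lt_trans; [apply Rabs_triang |].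
  eapply Rle_lt_trans; [apply Rplus_le_compat_r, Rabs_triang |].
  assert (Rabs (((gl (x0 + h) - G n (x0 + h)) - (gl x0 - G n x0)) / h) <= eps / 4); [| lra].
  unfold Rdiv. rewrite Rabs_mult, Rabs_inv.
  apply (Rmult_le_reg_r (Rabs h)); auto. rewrite Rmult_assoc, Rinv_l, Rmult_1_r by lra.
  eapply Rle_trans; [apply Rabs_triang |]. rewrite Rabs_Ropp.
  rewrite (Rabs_minus_sym (gl (x0 + h))), (Rabs_minus_sym (gl x0)). unfold eta in *. lra.
Qed.

Lemma unif_cv_phi_w p N (V : nat -> R -> R) v c1 c2 M : 1 < p -> 0 < c1 ->
  unif_cv V v (fun y => c1 < y < c2) -> (forall y, c1 < y < c2 -> Rabs (v y) <= M) ->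
  unif_cv (fun n y => phi_p_inv p (V n y / y ^ (N - 1))) (fun y => phi_p_inv p (v y / y ^ (N - 1)))
    (fun y => c1 < y < c2).
Proof.
  intros hp hc1 HV Hv. assert (hX : 0 < c1 ^ (N - 1)) by (apply pow_lt; auto).
  assert (Hk : forall y, c1 < y < c2 -> Rabs (/ y ^ (N - 1)) <= / c1 ^ (N - 1)).
  { intros y hy. rewrite Rabs_right by (left; apply Rinv_0_lt_compat, pow_lt; lra).
    apply Rinv_le_contravar; auto. apply pow_incr; lra. }
  apply (unif_cv_ext (fun n y => phi_p (conj_exp p) (/ y ^ (N - 1) * V n y)) _
                     (fun y => phi_p (conj_exp p) (/ y ^ (N - 1) * v y)));
    [intros; unfold phi_p_inv, Rdiv; rewrite Rmult_comm; reflexivity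
    | intros; unfold phi_p_inv, Rdiv; rewrite Rmult_comm; reflexivity |].
  apply (unif_cv_comp _ _ _ _ (/ c1 ^ (N - 1) * M));
    [intros x; apply continuous_phi_p, conj_exp_gt1; auto | |].
  - apply (unif_cv_scale _ _ _ _ (/ c1 ^ (N - 1))); auto. apply Rinv_0_lt_compat; auto.
  - intros y hy. rewrite Rabs_mult. apply Rmult_le_compat; auto; apply Rabs_pos.
Qed.

Lemma unif_cv_source N g (U : nat -> R -> R) u c1 c2 M : 0 <= c1 -> (forall s, continuous g s) ->
  unif_cv U u (fun y => c1 < y < c2) -> (forall y, c1 < y < c2 -> Rabs (u y) <= M) ->
  unif_cv (fun n y => - (y ^ (N - 1) * g (U n y))) (fun y => - (y ^ (N - 1) * g (u y)))
    (fun y => c1 < y < c2).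
Proof.
  intros hc1 Hgc HU Hu.
  apply (unif_cv_ext (fun n y => - (y ^ (N - 1)) * g (U n y)) _ (fun y => - (y ^ (N - 1)) * g (u y)));
    [intros; ring | intros; ring |].
  apply (unif_cv_scale _ _ _ _ (Rabs c2 ^ (N - 1) + 1)).
  - assert (0 <= Rabs c2 ^ (N - 1)) by (apply pow_le, Rabs_pos). lra.
  - apply (unif_cv_comp g _ _ _ M); auto.
  - intros y hy. rewrite Rabs_Ropp, Rabs_right by (apply Rle_ge, pow_le; lra).
    assert (y ^ (N - 1) <= Rabs c2 ^ (N - 1)); [| lra].
    apply pow_incr. rewrite Rabs_right; lra.
Qed.

Lemma right_continuous_phi_w_init p N v R1 b Bv : 1 < p -> R1 < b -> 0 <= R1 -> v R1 = 0 ->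
  (forall x, R1 < x < b -> Rabs (v x) <= Bv * x ^ (N - 1) * (x - R1)) ->
  right_continuous (fun y => phi_p_inv p (v y / y ^ (N - 1))) R1.
Proof.
  intros hp hb hR1 Hv0 Hvb eps he.
  destruct (continuous_eps_delta _ 0 (continuous_phi_p (conj_exp p) 0 (conj_exp_gt1 p hp)) eps he)
    as [e [he' He]].
  assert (hB := Rle_abs Bv). assert (0 <= Rabs Bv) by apply Rabs_pos.
  exists (Rmin (e / (Rabs Bv + 1)) (b - R1)).
  split; [apply Rmin_pos; [apply Rdiv_lt_0_compat |]; lra |].
  intros x hx. unfold phi_p_inv. rewrite Hv0. replace (0 / R1 ^ (N - 1)) with 0 by (unfold Rdiv; ring).
  apply He. rewrite Rminus_0_r.
  destruct (Req_dec x R1) as [->|hne]; [rewrite Hv0; unfold Rdiv; rewrite Rmult_0_l, Rabs_R0; lra |].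
  assert (h1 := Rmin_l (e / (Rabs Bv + 1)) (b - R1)). assert (h2 := Rmin_r (e / (Rabs Bv + 1)) (b - R1)).
  assert (HH : Rabs (v x) <= Rabs Bv * x ^ (N - 1) * (x - R1)).
  { eapply Rle_trans; [apply Hvb; lra |].
    apply Rmult_le_compat_r; [lra | apply Rmult_le_compat_r; [apply pow_le; lra | auto]]. }
  apply Rabs_div_pow_le in HH; [| lra].
  eapply Rle_lt_trans; [apply HH |].
  apply Rle_lt_trans with ((Rabs Bv + 1) * (x - R1)); [nra |].
  apply Rlt_le_trans with ((Rabs Bv + 1) * (e / (Rabs Bv + 1))); [apply Rmult_lt_compat_l; lra |].
  right; field; lra.
Qed.

Lemma lipschitz_of_unif_cv (Y : nat -> R -> R) z a b K : unif_cv Y z (fun x => a <= x <= b) ->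
  (forall n x y, a <= x <= b -> a <= y <= b -> Rabs (Y n x - Y n y) <= K * Rabs (x - y)) ->
  forall x y, a <= x <= b -> a <= y <= b -> Rabs (z x - z y) <= K * Rabs (x - y).
Proof.
  intros HY HL x y hx hy. apply (Un_cv_dist_le Y z x y); auto;
    [apply (unif_cv_Un_cv Y z _ x HY hx) | apply (unif_cv_Un_cv Y z _ y HY hy)].
Qed.

Lemma continuous_phi_w p N v r : 1 < p -> 0 < r -> continuous v r ->
  continuous (fun y => phi_p_inv p (v y / y ^ (N - 1))) r.
Proof.
  intros hp hr Hv. apply (continuous_comp (fun y => v y / y ^ (N - 1))).
  - apply continuous_div_pow; auto.
  - apply continuous_phi_p, conj_exp_gt1; auto.
Qed.

Lemma right_continuous_source (N : nat) g u a : (forall s, continuous g s) -> right_continuous u a ->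
  right_continuous (fun y => - (y ^ (N - 1) * g (u y))) a.
Proof.
  intros Hgc Hu eps he. destruct (right_continuous_mult (fun y => y ^ (N - 1)) (fun y => g (u y)) a)
    with eps as [e [he' He]]; auto.
  - apply continuous_right_continuous, continuous_Rpow, continuous_id.
  - apply right_continuous_comp; auto.
  - exists e. split; auto. intros x hx. specialize (He x hx).
    replace (- (x ^ (N - 1) * g (u x)) - - (a ^ (N - 1) * g (u a)))
      with (- (x ^ (N - 1) * g (u x) - a ^ (N - 1) * g (u a))) by ring.
    rewrite Rabs_Ropp. auto.
Qed.

Lemma limit_is_solution (p : R) (N : nat) (g : R -> R) (R1 b d : R) (U V A Bd : nat -> R -> R)
    (u v : R -> R) (Lu Lv Bv : R) :
  1 < p -> 0 <= R1 -> R1 < b -> (forall s, continuous g s) -> 0 <= Lu -> 0 <= Lv ->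
  u R1 = 1 - d -> v R1 = 0 ->
  unif_cv U u (fun x => R1 <= x <= b) -> unif_cv V v (fun x => R1 <= x <= b) ->
  (forall n x y, R1 <= x <= b -> R1 <= y <= b -> Rabs (U n x - U n y) <= Lu * Rabs (x - y)) ->
  (forall n x y, R1 <= x <= b -> R1 <= y <= b -> Rabs (V n x - V n y) <= Lv * Rabs (x - y)) ->
  (forall n y, R1 < y < b -> is_derive (U n) y (A n y) /\ is_derive (V n) y (Bd n y)) ->
  (forall c1 c2, R1 < c1 -> c1 < c2 -> c2 < b ->
     unif_cv A (fun y => phi_p_inv p (v y / y ^ (N - 1))) (fun y => c1 < y < c2) /\
     unif_cv Bd (fun y => - (y ^ (N - 1) * g (u y))) (fun y => c1 < y < c2)) ->
  (forall x, R1 < x < b -> Rabs (v x) <= Bv * x ^ (N - 1) * (x - R1)) ->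
  is_solution_g p N g R1 d u v b.
Proof.
  intros hp hR1 hb Hgc hLu hLv Hu0 Hv0 HU HV HLU HLV Hd Hf Hvb.
  set (Fu := fun y => phi_p_inv p (v y / y ^ (N - 1))).
  set (Fv := fun y => - (y ^ (N - 1) * g (u y))).
  assert (Lip_u := lipschitz_of_unif_cv U u R1 b Lu HU HLU).
  assert (Lip_v := lipschitz_of_unif_cv V v R1 b Lv HV HLV).
  assert (Cu : forall r, R1 < r < b -> continuous u r) by (intros; apply (lipschitz_continuous u R1 b Lu); auto).
  assert (Cv : forall r, R1 < r < b -> continuous v r) by (intros; apply (lipschitz_continuous v R1 b Lv); auto).
  assert (Ru : right_continuous u R1) by (apply (lipschitz_right_continuous u R1 b Lu); auto).
  assert (Rv : right_continuous v R1) by (apply (lipschitz_right_continuous v R1 b Lv); auto).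
  assert (CFu : forall r, R1 < r < b -> continuous Fu r)
    by (intros r hr; apply continuous_phi_w; auto; lra).
  assert (CFv : forall r, R1 < r < b -> continuous Fv r).
  { intros r hr. unfold Fv. apply continuous_Ropp, continuous_Rmult; [apply continuous_Rpow, continuous_id |].
    apply (continuous_comp u g); [apply Cu; auto | apply Hgc]. }
  assert (Dr : forall r, R1 < r < b -> is_derive u r (Fu r) /\ is_derive v r (Fv r)).
  { intros r hr. destruct (Hf ((R1 + r) / 2) ((r + b) / 2) ltac:(lra) ltac:(lra) ltac:(lra)) as [H1 H2].
    split.
    - apply (is_derive_of_unif_cv U A u Fu r ((R1 + r) / 2) ((r + b) / 2)); auto; [lra | |].
      + intros n y hy. apply Hd. lra.
      + intros y hy. apply (unif_cv_Un_cv U u _ y HU). lra.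
    - apply (is_derive_of_unif_cv V Bd v Fv r ((R1 + r) / 2) ((r + b) / 2)); auto; [lra | |].
      + intros n y hy. apply Hd. lra.
      + intros y hy. apply (unif_cv_Un_cv V v _ y HV). lra. }
  assert (RFu : right_continuous Fu R1) by (apply (right_continuous_phi_w_init p N v R1 b Bv); auto).
  assert (RFv : right_continuous Fv R1) by (apply right_continuous_source; auto).
  refine (conj hb (conj _ (conj _ (conj Hu0 (conj Hv0 _))))).
  - exists Fu. split; [intros r hr; split; [apply Dr | apply CFu]; auto |].
    split; [apply (right_derivative_of_derive_limit u Fu R1 b); auto; intros; apply Dr; auto |].
    apply filterlim_of_right_continuous; auto.
  - exists Fv. split; [intros r hr; split; [apply Dr | apply CFv]; auto |].
    split; [apply (right_derivative_of_derive_limit v Fv R1 b); auto; intros; apply Dr; auto |].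
    apply filterlim_of_right_continuous; auto.
  - intros r hr _. apply Dr; auto.
Qed.

Lemma continuous_Rmax_r a x : continuous (fun y => Rmax a y) x.
Proof.
  apply continuous_of_eps_delta. intros eps he. exists eps. split; auto. intros y hy.
  unfold Rmax. destruct (Rle_dec a y); destruct (Rle_dec a x); apply Rabs_def2 in hy;
    apply Rabs_def1; lra.
Qed.

Lemma continuous_Rmin_l a x : continuous (fun y => Rmin y a) x.
Proof.
  apply continuous_of_eps_delta. intros eps he. exists eps. split; auto. intros y hy.
  unfold Rmin. destruct (Rle_dec y a); destruct (Rle_dec x a); apply Rabs_def2 in hy;
    apply Rabs_def1; lra.
Qed.

(** Tonelli's delayed scheme: the right-hand side is evaluated at [r - h], so the [j]-th
    iterate of [tonelli_step] is already stationary on [(-oo, R1 + j h]]. *)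
Section Tonelli.
Variables (p : R) (N : nat) (R1 u0 : R) (g : R -> R) (h : R).
Hypothesis hp : 1 < p.
Hypothesis hR1 : 0 <= R1.
Hypothesis hh : 0 < h.
Hypothesis Hgc : forall s, continuous g s.

Definition tonelli_rhs_u (V : R -> R) (r : R) := phi_p_inv p (V (r - h) / r ^ (N - 1)).
Definition tonelli_rhs_v (U : R -> R) (r : R) := - (r ^ (N - 1) * g (U (r - h))).

Definition tonelli_step (UV : (R -> R) * (R -> R)) : (R -> R) * (R -> R) :=
  (fun x => u0 + RInt (tonelli_rhs_u (snd UV)) R1 (Rmax R1 x),
   fun x => RInt (tonelli_rhs_v (fst UV)) R1 (Rmax R1 x)).

Fixpoint tonelli_iter (j : nat) : (R -> R) * (R -> R) :=
  match j with
  | O => (fun _ => u0, fun _ => 0)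
  | S j' => tonelli_step (tonelli_iter j')
  end.

Definition tonelli_inv (UV : (R -> R) * (R -> R)) :=
  (forall x, continuous (fst UV) x) /\ (forall x, continuous (snd UV) x) /\
  (forall y, y <= R1 -> fst UV y = u0 /\ snd UV y = 0).

Lemma continuous_tonelli_rhs_u V : (forall x, continuous V x) -> (forall y, y <= R1 -> V y = 0) ->
  forall z, continuous (tonelli_rhs_u V) z.
Proof.
  intros Hc H0 z. unfold tonelli_rhs_u, phi_p_inv. destruct (Rlt_dec z (R1 + h)) as [hz|hz].
  - apply (continuous_ext_loc _ (fun _ => 0)); [| apply continuous_const].
    apply (filter_imp (fun y => y < R1 + h)); [| apply locally_lt; auto].
    intros y hy. rewrite H0 by lra. unfold Rdiv. rewrite Rmult_0_l, phi_p_0. auto.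
  - apply (continuous_comp (fun y => V (y - h) / y ^ (N - 1)));
      [| apply continuous_phi_p, conj_exp_gt1; auto].
    apply continuous_div_pow; [lra |].
    apply (continuous_comp (fun y => y - h) V); [| apply Hc].
    apply continuous_Rminus; [apply continuous_id | apply continuous_const].
Qed.

Lemma continuous_tonelli_rhs_v U : (forall x, continuous U x) -> forall z, continuous (tonelli_rhs_v U) z.
Proof.
  intros Hc z. unfold tonelli_rhs_v.
  apply continuous_Ropp, continuous_Rmult; [apply continuous_Rpow, continuous_id |].
  apply (continuous_comp (fun y => U (y - h)) g); [| apply Hgc].
  apply (continuous_comp (fun y => y - h) U); [| apply Hc].
  apply continuous_Rminus; [apply continuous_id | apply continuous_const].
Qed.

Lemma tonelli_step_inv UV : tonelli_inv UV -> tonelli_inv (tonelli_step UV).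
Proof.
  intros [Hu [Hv H0]]. unfold tonelli_step, tonelli_inv; simpl.
  assert (CU := continuous_tonelli_rhs_u (snd UV) Hv (fun y hy => proj2 (H0 y hy))).
  assert (CV := continuous_tonelli_rhs_v (fst UV) Hu).
  split; [| split].
  - intros x. apply continuous_Rplus; [apply continuous_const |].
    apply (continuous_comp (fun y => Rmax R1 y) (fun y => RInt (tonelli_rhs_u (snd UV)) R1 y));
      [apply continuous_Rmax_r | apply continuous_RInt_upper; auto].
  - intros x. apply (continuous_comp (fun y => Rmax R1 y) (fun y => RInt (tonelli_rhs_v (fst UV)) R1 y));
      [apply continuous_Rmax_r | apply continuous_RInt_upper; auto].
  - intros y hy. rewrite Rmax_left by lra. rewrite !RInt_point. split; [apply Rplus_0_r | auto].
Qed.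

Lemma tonelli_iter_inv j : tonelli_inv (tonelli_iter j).
Proof.
  induction j; [| apply tonelli_step_inv; auto].
  split; [| split]; simpl; auto; intros; apply continuous_const.
Qed.

Lemma is_derive_tonelli_step UV r : tonelli_inv UV -> R1 < r ->
  is_derive (fst (tonelli_step UV)) r (tonelli_rhs_u (snd UV) r) /\
  is_derive (snd (tonelli_step UV)) r (tonelli_rhs_v (fst UV) r).
Proof.
  intros [Hu [Hv H0]] hr.
  assert (CU := continuous_tonelli_rhs_u (snd UV) Hv (fun y hy => proj2 (H0 y hy))).
  assert (CV := continuous_tonelli_rhs_v (fst UV) Hu).
  assert (Hl : locally r (fun y => Rmax R1 y = y)).
  { apply (filter_imp (fun y => R1 < y)); [| apply locally_gt; auto]. intros y hy. apply Rmax_right; lra. }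
  unfold tonelli_step; simpl. split.
  - apply is_derive_ext_loc with (fun y => u0 + RInt (tonelli_rhs_u (snd UV)) R1 y).
    { apply (filter_imp _ _ (fun y hy => f_equal (fun t => u0 + RInt _ R1 t) (eq_sym hy)) Hl). }
    apply is_derive_eq with (0 + tonelli_rhs_u (snd UV) r); [ring |].
    apply is_derive_Rplus; [apply (is_derive_const u0) | apply is_derive_RInt_upper; auto].
  - apply is_derive_ext_loc with (fun y => RInt (tonelli_rhs_v (fst UV)) R1 y).
    { apply (filter_imp _ _ (fun y hy => f_equal (fun t => RInt _ R1 t) (eq_sym hy)) Hl). }
    apply is_derive_RInt_upper; auto.
Qed.

Lemma tonelli_iter_stable j : forall x, x <= R1 + INR j * h ->
  fst (tonelli_iter (S j)) x = fst (tonelli_iter j) x /\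
  snd (tonelli_iter (S j)) x = snd (tonelli_iter j) x.
Proof.
  induction j; intros x hx.
  - simpl in hx. rewrite Rmult_0_l, Rplus_0_r in hx. simpl. unfold tonelli_step; simpl.
    rewrite Rmax_left by lra. rewrite !RInt_point. split; [apply Rplus_0_r | auto].
  - assert (E1 : fst (tonelli_iter (S (S j))) x
                 = u0 + RInt (tonelli_rhs_u (snd (tonelli_iter (S j)))) R1 (Rmax R1 x)) by reflexivity.
    assert (E2 : fst (tonelli_iter (S j)) x
                 = u0 + RInt (tonelli_rhs_u (snd (tonelli_iter j))) R1 (Rmax R1 x)) by reflexivity.
    assert (E3 : snd (tonelli_iter (S (S j))) x
                 = RInt (tonelli_rhs_v (fst (tonelli_iter (S j)))) R1 (Rmax R1 x)) by reflexivity.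
    assert (E4 : snd (tonelli_iter (S j)) x
                 = RInt (tonelli_rhs_v (fst (tonelli_iter j))) R1 (Rmax R1 x)) by reflexivity.
    rewrite E1, E2, E3, E4. rewrite S_INR in hx.
    assert (Hy : forall y, Rmin R1 (Rmax R1 x) < y < Rmax R1 (Rmax R1 x) -> y - h <= R1 + INR j * h).
    { intros y hy. unfold Rmin, Rmax in hy.
      destruct (Rle_dec R1 x); destruct (Rle_dec R1 (Rmax R1 x)); unfold Rmax in *;
        destruct (Rle_dec R1 x); lra. }
    split.
    + f_equal. apply RInt_ext. intros y hy. unfold tonelli_rhs_u.
      rewrite (proj2 (IHj (y - h) (Hy y hy))). auto.
    + apply RInt_ext. intros y hy. unfold tonelli_rhs_v. rewrite (proj1 (IHj (y - h) (Hy y hy))). auto.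
Qed.

End Tonelli.

Section TonelliBounds.
Variables (p : R) (N : nat) (R1 u0 : R) (g : R -> R) (h b B : R) (J : nat).
Hypothesis hp : 1 < p.
Hypothesis hR1 : 0 <= R1.
Hypothesis hh : 0 < h.
Hypothesis Hgc : forall s, continuous g s.
Hypothesis hb : R1 < b.
Hypothesis hJ : b <= R1 + INR J * h.
Hypothesis HB : forall s, Rabs (g s) <= B.

Definition tonelli_u := fst (tonelli_iter p N R1 u0 g h (S J)).
Definition tonelli_v := snd (tonelli_iter p N R1 u0 g h (S J)).

Let Hinv : tonelli_inv R1 u0 (tonelli_u, tonelli_v) := tonelli_iter_inv p N R1 u0 g h hp hR1 hh Hgc (S J).

Lemma continuous_tonelli_u x : continuous tonelli_u x.
Proof. apply (proj1 Hinv). Qed.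

Lemma continuous_tonelli_v x : continuous tonelli_v x.
Proof. apply (proj1 (proj2 Hinv)). Qed.

Lemma tonelli_init y : y <= R1 -> tonelli_u y = u0 /\ tonelli_v y = 0.
Proof. apply (proj2 (proj2 Hinv)). Qed.

Lemma is_derive_tonelli r : R1 < r < b ->
  is_derive tonelli_u r (phi_p_inv p (tonelli_v (r - h) / r ^ (N - 1))) /\
  is_derive tonelli_v r (- (r ^ (N - 1) * g (tonelli_u (r - h)))).
Proof.
  intros hr.
  destruct (is_derive_tonelli_step p N R1 u0 g h hp hR1 hh Hgc (tonelli_iter p N R1 u0 g h J) r
              (tonelli_iter_inv p N R1 u0 g h hp hR1 hh Hgc J) ltac:(lra)) as [H1 H2].
  destruct (tonelli_iter_stable p N R1 u0 g h J (r - h) ltac:(lra)) as [E1 E2].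
  unfold tonelli_u, tonelli_v. simpl tonelli_iter.
  unfold tonelli_rhs_u, tonelli_rhs_v in *. simpl in E1, E2.
  rewrite <- E2 in H1. rewrite <- E1 in H2. auto.
Qed.

Lemma g_bound_ge0 : 0 <= B.
Proof. eapply Rle_trans; [apply Rabs_pos | apply (HB 0)]. Qed.

Definition tonelli_v_slope := b ^ (N - 1) * B.
Definition tonelli_u_slope := Rpower0 (B * (b - R1)) (conj_exp p - 1).

Lemma tonelli_v_slope_ge0 : 0 <= tonelli_v_slope.
Proof. apply Rmult_le_pos; [apply pow_le; lra | apply g_bound_ge0]. Qed.

Lemma tonelli_v_bound x : R1 <= x <= b -> Rabs (tonelli_v x) <= B * x ^ (N - 1) * (x - R1).
Proof.
  intros hx. destruct (Req_dec x R1) as [->|hne].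
  { rewrite (proj2 (tonelli_init R1 ltac:(lra))), Rabs_R0, Rminus_eq_0. lra. }
  replace (tonelli_v x) with (tonelli_v x - tonelli_v R1) by (rewrite (proj2 (tonelli_init R1 ltac:(lra))); ring).
  apply (Rabs_incr_le_of_derive_bound tonelli_v (fun c => - (c ^ (N - 1) * g (tonelli_u (c - h)))));
    [lra | intros c hc; apply is_derive_tonelli; lra
    | apply continuous_right_continuous, continuous_tonelli_v | apply continuous_tonelli_v |].
  intros c hc. rewrite Rabs_Ropp, Rabs_mult, Rabs_right by (apply Rle_ge, pow_le; lra).
  assert (c ^ (N - 1) <= x ^ (N - 1)) by (apply pow_incr; lra).
  assert (0 <= c ^ (N - 1)) by (apply pow_le; lra).
  specialize (HB (tonelli_u (c - h))). assert (0 <= Rabs (g (tonelli_u (c - h)))) by apply Rabs_pos.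
  rewrite Rmult_comm. apply Rmult_le_compat; lra.
Qed.

Lemma tonelli_v_lip x y : x <= y -> R1 <= y <= b -> Rabs (tonelli_v y - tonelli_v x) <= tonelli_v_slope * (y - x).
Proof.
  intros hxy hy.
  assert (Hlip : forall x y, R1 <= x <= y -> y <= b ->
            Rabs (tonelli_v y - tonelli_v x) <= tonelli_v_slope * (y - x)).
  { clear x y hxy hy. intros x y hx hy.
    apply (Rabs_incr_le_of_derive_bound tonelli_v (fun c => - (c ^ (N - 1) * g (tonelli_u (c - h)))));
      [lra | intros c hc; apply is_derive_tonelli; lra
      | apply continuous_right_continuous, continuous_tonelli_v | apply continuous_tonelli_v |].
    intros c hc. unfold tonelli_v_slope. rewrite Rabs_Ropp, Rabs_mult, Rabs_right by (apply Rle_ge, pow_le; lra).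
    assert (c ^ (N - 1) <= b ^ (N - 1)) by (apply pow_incr; lra).
    assert (0 <= c ^ (N - 1)) by (apply pow_le; lra).
    specialize (HB (tonelli_u (c - h))). assert (0 <= Rabs (g (tonelli_u (c - h)))) by apply Rabs_pos.
    apply Rmult_le_compat; lra. }
  destruct (Rle_dec R1 x); [apply Hlip; lra |].
  rewrite (proj2 (tonelli_init x ltac:(lra))).
  replace (tonelli_v y - 0) with (tonelli_v y - tonelli_v R1) by (rewrite (proj2 (tonelli_init R1 ltac:(lra))); ring).
  eapply Rle_trans; [apply Hlip; lra |].
  apply Rmult_le_compat_l; [apply tonelli_v_slope_ge0 | lra].
Qed.

Lemma tonelli_u_slope_bound r : R1 < r < b ->
  Rabs (phi_p_inv p (tonelli_v (r - h) / r ^ (N - 1))) <= tonelli_u_slope.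
Proof.
  intros hr. unfold phi_p_inv, tonelli_u_slope. rewrite Rabs_phi_p.
  assert (Hq := conj_exp_gt1 p hp).
  apply Rpower0_le; [lra |]. split; [apply Rabs_pos |]. assert (hB := g_bound_ge0).
  destruct (Rle_dec (r - h) R1).
  - rewrite (proj2 (tonelli_init (r - h) r0)). unfold Rdiv. rewrite Rmult_0_l, Rabs_R0.
    apply Rmult_le_pos; lra.
  - apply Rabs_div_pow_le; [lra |]. eapply Rle_trans; [apply tonelli_v_bound; lra |].
    assert ((r - h) ^ (N - 1) <= r ^ (N - 1)) by (apply pow_incr; lra).
    assert (0 <= (r - h) ^ (N - 1)) by (apply pow_le; lra).
    replace (B * r ^ (N - 1) * (b - R1)) with (B * (r ^ (N - 1) * (b - R1))) by ring.
    rewrite Rmult_assoc. apply Rmult_le_compat_l; auto. apply Rmult_le_compat; lra.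
Qed.

Lemma tonelli_u_lip x y : x <= y -> R1 <= y <= b -> Rabs (tonelli_u y - tonelli_u x) <= tonelli_u_slope * (y - x).
Proof.
  intros hxy hy. assert (hW : 0 <= tonelli_u_slope) by apply Rpower0_ge0.
  assert (Hlip : forall x y, R1 <= x <= y -> y <= b ->
            Rabs (tonelli_u y - tonelli_u x) <= tonelli_u_slope * (y - x)).
  { clear x y hxy hy. intros x y hx hy.
    apply (Rabs_incr_le_of_derive_bound tonelli_u (fun c => phi_p_inv p (tonelli_v (c - h) / c ^ (N - 1))));
      [lra | intros c hc; apply is_derive_tonelli; lra
      | apply continuous_right_continuous, continuous_tonelli_u | apply continuous_tonelli_u |].
    intros c hc. apply tonelli_u_slope_bound. lra. }
  destruct (Rle_dec R1 x); [apply Hlip; lra |].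
  rewrite (proj1 (tonelli_init x ltac:(lra))).
  replace (tonelli_u y - u0) with (tonelli_u y - tonelli_u R1) by (rewrite (proj1 (tonelli_init R1 ltac:(lra))); ring).
  eapply Rle_trans; [apply Hlip; lra | apply Rmult_le_compat_l; lra].
Qed.

Lemma tonelli_u_bound x : R1 <= x <= b -> Rabs (tonelli_u x) <= Rabs u0 + tonelli_u_slope * (b - R1).
Proof.
  intros hx. assert (hW : 0 <= tonelli_u_slope) by apply Rpower0_ge0.
  replace (tonelli_u x) with ((tonelli_u x - tonelli_u R1) + u0)
    by (rewrite (proj1 (tonelli_init R1 ltac:(lra))); ring).
  eapply Rle_trans; [apply Rabs_triang |]. assert (H := tonelli_u_lip R1 x ltac:(lra) ltac:(lra)).
  assert (tonelli_u_slope * (x - R1) <= tonelli_u_slope * (b - R1)) by (apply Rmult_le_compat_l; lra). lra.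
Qed.

Lemma tonelli_v_bound_unif x : R1 <= x <= b -> Rabs (tonelli_v x) <= tonelli_v_slope * (b - R1).
Proof.
  intros hx. replace (tonelli_v x) with (tonelli_v x - tonelli_v R1)
    by (rewrite (proj2 (tonelli_init R1 ltac:(lra))); ring).
  eapply Rle_trans; [apply tonelli_v_lip; lra |].
  apply Rmult_le_compat_l; [apply tonelli_v_slope_ge0 | lra].
Qed.

End TonelliBounds.

Lemma unif_cv_delay (W : nat -> R -> R) (w : R -> R) (hn : nat -> R) (R1 b Lw c1 c2 : R) :
  R1 < c1 -> c2 <= b -> 0 <= Lw -> unif_cv W w (fun x => R1 <= x <= b) ->
  (forall n x y, x <= y -> R1 <= y <= b -> Rabs (W n y - W n x) <= Lw * (y - x)) ->
  (forall n, 0 < hn n) -> Un_cv hn 0 ->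
  unif_cv (fun n y => W n (y - hn n)) w (fun y => c1 < y < c2).
Proof.
  intros h1 h2 hL Hc Hl Hh Hs eps he.
  destruct (Hc (eps / 2) ltac:(lra)) as [N1 HN1].
  destruct (Hs (eps / (2 * (Lw + 1))) ltac:(apply Rdiv_lt_0_compat; lra)) as [N2 HN2].
  exists (max N1 N2). intros n hnn y hy.
  specialize (HN1 n ltac:(lia) y ltac:(lra)). specialize (HN2 n ltac:(lia)).
  unfold Rdist in HN2. rewrite Rminus_0_r, Rabs_right in HN2 by (specialize (Hh n); lra).
  specialize (Hl n (y - hn n) y ltac:(specialize (Hh n); lra) ltac:(lra)).
  replace (W n (y - hn n) - w y) with (- (W n y - W n (y - hn n)) + (W n y - w y)) by ring.
  eapply Rle_trans; [apply Rabs_triang |]. rewrite Rabs_Ropp.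
  replace (y - (y - hn n)) with (hn n) in Hl by ring.
  assert (Lw * hn n <= eps / 2); [| lra].
  apply Rle_trans with ((Lw + 1) * (eps / (2 * (Lw + 1)))); [| right; field; lra].
  apply Rmult_le_compat; try lra. specialize (Hh n); lra.
Qed.

Section BoundedExistence.
Variables (p : R) (N : nat) (R1 b d : R) (g : R -> R) (B : R).
Hypothesis hp : 1 < p.
Hypothesis hR1 : 0 <= R1.
Hypothesis hb : R1 < b.
Hypothesis Hgc : forall s, continuous g s.
Hypothesis HB : forall s, Rabs (g s) <= B.

Let step k := / (INR k + 1).
Let nsteps k := (S k * Z.to_nat (up (b - R1)))%nat.
Let Uk k := tonelli_u p N R1 (1 - d) g (step k) (nsteps k).
Let Vk k := tonelli_v p N R1 (1 - d) g (step k) (nsteps k).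
Let LU := tonelli_u_slope p R1 b B.
Let LV := tonelli_v_slope N b B.

Lemma step_pos k : 0 < step k.
Proof. apply Rinv_0_lt_compat. assert (0 <= INR k) by apply pos_INR. lra. Qed.

Lemma nsteps_enough k : b <= R1 + INR (nsteps k) * step k.
Proof.
  unfold nsteps, step. rewrite mult_INR, S_INR.
  replace ((INR k + 1) * INR (Z.to_nat (up (b - R1))) * / (INR k + 1)) with (INR (Z.to_nat (up (b - R1))))
    by (field; assert (0 <= INR k) by apply pos_INR; lra).
  destruct (archimed (b - R1)) as [hA _].
  rewrite INR_IZR_INZ, Z2Nat.id by (apply le_IZR; lra). lra.
Qed.

Local Hint Resolve step_pos nsteps_enough : core.


Lemma approx_u_lipschitz n x y : R1 <= x <= b -> R1 <= y <= b -> Rabs (Uk n x - Uk n y) <= LU * Rabs (x - y).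
Proof.
  apply lipschitz_of_incr_bound. intros x' y' hx hy.
  apply (tonelli_u_lip p N R1 (1 - d) g (step n) b B (nsteps n)); auto; lra.
Qed.

Lemma approx_v_lipschitz n x y : R1 <= x <= b -> R1 <= y <= b -> Rabs (Vk n x - Vk n y) <= LV * Rabs (x - y).
Proof.
  apply lipschitz_of_incr_bound. intros x' y' hx hy.
  apply (tonelli_v_lip p N R1 (1 - d) g (step n) b B (nsteps n)); auto; lra.
Qed.

Theorem solution_exists_bounded : exists u v, is_solution_g p N g R1 d u v b.
Proof.
  assert (hLU : 0 <= LU) by apply Rpower0_ge0.
  assert (hLV : 0 <= LV) by (apply (tonelli_v_slope_ge0 N R1 g b B); auto).
  assert (HUlip := approx_u_lipschitz). assert (HVlip := approx_v_lipschitz).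
  destruct (Arzela_Ascoli2 Uk Vk R1 b (Rabs (1 - d) + LU * (b - R1)) (LV * (b - R1)) LU LV)
    as [kap [u [v [Hkap [Hu Hv]]]]]; auto; try lra.
  { intros n x hx. apply (tonelli_u_bound p N R1 (1 - d) g (step n) b B (nsteps n)); auto. }
  { intros n x hx. apply (tonelli_v_bound_unif p N R1 (1 - d) g (step n) b B (nsteps n)); auto. }
  assert (HcU := fun x hx => unif_cv_Un_cv _ _ (fun x => R1 <= x <= b) x Hu hx).
  assert (HcV := fun x hx => unif_cv_Un_cv _ _ (fun x => R1 <= x <= b) x Hv hx).
  assert (Hub := unif_cv_bound _ _ _ (Rabs (1 - d) + LU * (b - R1)) Hu
                  (fun n => tonelli_u_bound p N R1 (1 - d) g (step (kap n)) b B (nsteps (kap n))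
                              hp hR1 (step_pos _) Hgc hb (nsteps_enough _) HB)).
  assert (Hvb := unif_cv_bound _ _ _ (LV * (b - R1)) Hv
                  (fun n => tonelli_v_bound_unif p N R1 (1 - d) g (step (kap n)) b B (nsteps (kap n))
                              hp hR1 (step_pos _) Hgc hb (nsteps_enough _) HB)).
  assert (Hstep : Un_cv (fun n => step (kap n)) 0).
  { intros eps he. destruct (inv_INR_succ_small eps he) as [n0 Hn0]. exists n0. intros n hn.
    unfold Rdist. rewrite Rminus_0_r, Rabs_right by (left; apply step_pos).
    apply Hn0. assert (H := extraction_ge kap Hkap n). lia. }
  exists u, v.
  apply (limit_is_solution p N g R1 b d (fun n => Uk (kap n)) (fun n => Vk (kap n))
     (fun n y => phi_p_inv p (Vk (kap n) (y - step (kap n)) / y ^ (N - 1)))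
     (fun n y => - (y ^ (N - 1) * g (Uk (kap n) (y - step (kap n))))) u v LU LV B);
    auto; [| | | |].
  - apply (Un_cv_const_eq _ _ _ (HcU R1 ltac:(lra))). intros n.
    apply (tonelli_init p N R1 (1 - d) g (step (kap n)) (nsteps (kap n))); auto; lra.
  - apply (Un_cv_const_eq _ _ _ (HcV R1 ltac:(lra))). intros n.
    apply (tonelli_init p N R1 (1 - d) g (step (kap n)) (nsteps (kap n))); auto; lra.
  - intros n y hy. apply (is_derive_tonelli p N R1 (1 - d) g (step (kap n)) b (nsteps (kap n))); auto.
  - intros c1 c2 hc1 hc12 hc2. split.
    + apply (unif_cv_phi_w p N _ _ c1 c2 (LV * (b - R1))); auto; [lra | | intros; apply Hvb; lra].
      apply (unif_cv_delay (fun n => Vk (kap n)) v (fun n => step (kap n)) R1 b LV); auto; try lra.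
      intros n x y hxy hy. apply (tonelli_v_lip p N R1 (1 - d) g (step (kap n)) b B (nsteps (kap n))); auto.
    + apply (unif_cv_source N g _ _ c1 c2 (Rabs (1 - d) + LU * (b - R1))); auto; [lra | | intros; apply Hub; lra].
      apply (unif_cv_delay (fun n => Uk (kap n)) u (fun n => step (kap n)) R1 b LU); auto; try lra.
      intros n x y hxy hy. apply (tonelli_u_lip p N R1 (1 - d) g (step (kap n)) b B (nsteps (kap n))); auto.
  - intros x hx. apply (Un_cv_bound _ _ _ (HcV x ltac:(lra))). intros n.
    apply (tonelli_v_bound p N R1 (1 - d) g (step (kap n)) b B (nsteps (kap n))); auto; lra.
Qed.

End BoundedExistence.

Lemma is_solution_g_ext p N (g1 g2 : R -> R) R1 d u v rs : is_solution_g p N g1 R1 d u v rs ->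
  (forall r, R1 < r < rs -> g1 (u r) = g2 (u r)) -> is_solution_g p N g2 R1 d u v rs.
Proof.
  intros [h1 [h2 [h3 [h4 [h5 h6]]]]] He. refine (conj h1 (conj h2 (conj h3 (conj h4 (conj h5 _))))).
  intros r hr hr0. destruct (h6 r hr hr0) as [A1 A2]. split; auto. rewrite <- He; auto.
Qed.

Section SolutionBounds.
Variables (p : R) (N : nat) (g : R -> R) (R1 R2 d : R) (u v : R -> R) (rs : R).
Hypothesis hp : 1 < p.
Hypothesis hR1 : 0 <= R1.
Hypothesis Hg : admissible g.
Hypothesis hd : 0 <= d <= 1.
Hypothesis hrs : R2 < rs.
Hypothesis Hs : is_solution_g p N g R1 d u v rs.

Lemma sol_u_lipschitz x y : R1 <= x <= R2 -> R1 <= y <= R2 ->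
  Rabs (u x - u y) <= slope_bound p g * Rabs (x - y).
Proof.
  apply (lipschitz_of_incr_bound u R1 R2). intros a c ha hc.
  destruct (Req_dec a c) as [->|hne]; [rewrite !Rminus_eq_0, Rabs_R0; lra |].
  apply (Rabs_incr_le_of_derive_bound u (fun y => phi_p_inv p (v y / y ^ (N - 1)))); [lra | | | |].
  - intros z hz. apply (sol_derive_u hR1 Hs); lra.
  - apply (sol_right_continuous_u hR1 Hs); lra.
  - apply (sol_continuous_u hR1 Hs); lra.
  - intros z hz. apply (sol_derive_u_bounded hp hR1 Hg Hs); auto; lra.
Qed.

Lemma sol_u_bound x : R1 <= x <= R2 -> Rabs (u x) <= 1 + slope_bound p g * (R2 - R1).
Proof.
  intros hx. assert (H := sol_u_lipschitz x R1 hx ltac:(lra)).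
  rewrite (sol_u_init Hs), (Rabs_right (x - R1)) in H by lra.
  replace (u x) with ((u x - (1 - d)) + (1 - d)) by ring. eapply Rle_trans; [apply Rabs_triang |].
  rewrite (Rabs_right (1 - d)) by lra.
  assert (slope_bound p g * (x - R1) <= slope_bound p g * (R2 - R1))
    by (apply Rmult_le_compat_l; [apply slope_bound_ge0 | lra]).
  lra.
Qed.

Variable Bf : R.
Hypothesis hBf : 0 <= Bf.
Hypothesis HBf : forall s, Rabs s <= 1 + slope_bound p g * (R2 - R1) -> Rabs (g s) <= Bf.

Lemma sol_v_lipschitz x y : R1 <= x <= R2 -> R1 <= y <= R2 ->
  Rabs (v x - v y) <= R2 ^ (N - 1) * Bf * Rabs (x - y).
Proof.
  apply (lipschitz_of_incr_bound v R1 R2). intros a c ha hc.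
  destruct (Req_dec a c) as [->|hne]; [rewrite !Rminus_eq_0, Rabs_R0; lra |].
  apply (Rabs_incr_le_of_derive_bound v (fun y => - (y ^ (N - 1) * g (u y)))); [lra | | | |].
  - intros z hz. apply (sol_derive_v hR1 Hs); lra.
  - apply (sol_right_continuous_v hR1 Hs); lra.
  - apply (sol_continuous_v hR1 Hs); lra.
  - intros z hz. rewrite Rabs_Ropp, Rabs_mult, Rabs_right by (apply Rle_ge, pow_le; lra).
    assert (z ^ (N - 1) <= R2 ^ (N - 1)) by (apply pow_incr; lra).
    assert (0 <= z ^ (N - 1)) by (apply pow_le; lra).
    assert (Rabs (g (u z)) <= Bf) by (apply HBf, sol_u_bound; lra).
    apply Rmult_le_compat; auto; try lra. apply Rabs_pos.
Qed.

Lemma sol_v_bound x : R1 < x <= R2 -> Rabs (v x) <= Bf * x ^ (N - 1) * (x - R1).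
Proof.
  intros hx. assert (H := sol_v_incr_bound hR1 Hs R1 x Bf ltac:(lra) ltac:(lra)).
  rewrite (sol_v_init Hs), Rminus_0_r in H. apply H.
  intros c hc. apply HBf, sol_u_bound; lra.
Qed.

Lemma sol_v_bound_unif x : R1 <= x <= R2 -> Rabs (v x) <= R2 ^ (N - 1) * Bf * (R2 - R1).
Proof.
  intros hx. replace (v x) with (v x - v R1) by (rewrite (sol_v_init Hs); ring).
  eapply Rle_trans; [apply sol_v_lipschitz; lra |].
  apply Rmult_le_compat_l; [apply Rmult_le_pos; [apply pow_le |]; lra |].
  rewrite Rabs_right; lra.
Qed.

End SolutionBounds.

Lemma admissible_truncate g c : admissible g -> 1 < c -> admissible (fun s => g (Rmin s c)).
Proof.
  intros [Hc [H0 [H1 [Hn Hp]]]] hc.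
  split; [intros s; apply (continuous_comp (fun s => Rmin s c) g); [apply continuous_Rmin_l | apply Hc] |].
  split; [| split; [| split]].
  - intros s hs. rewrite Rmin_left by lra. auto.
  - rewrite Rmin_left by lra. auto.
  - intros s hs. rewrite Rmin_left by lra. auto.
  - intros s hs. apply Hp. unfold Rmin; destruct (Rle_dec s c); lra.
Qed.

Lemma slope_bound_truncate p g c : 1 <= c -> slope_bound p (fun s => g (Rmin s c)) = slope_bound p g.
Proof.
  intros hc. unfold slope_bound, w_bound, primitive. do 4 f_equal.
  apply RInt_ext. intros x hx. rewrite Rmin_left; auto.
  rewrite Rmax_right in hx by lra. lra.
Qed.

(** Existence on [[R1, R2 + 1)]: solve with [fhat f] truncated above at a level that the
    a priori bound [|u| <= 1 + slope_bound (r - R1)] shows is never reached. *)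
Theorem solution_exists p N f R1 R2 d : 1 < p -> 0 <= R1 -> R1 < R2 -> f_reg f -> f_eq f ->
  0 <= d <= 1 -> exists u v, is_solution_g p N (fhat f) R1 d u v (R2 + 1).
Proof.
  intros hp hR1 hR12 Hreg Heq hd.
  set (b := R2 + 1). set (D0 := slope_bound p (fhat f)).
  assert (hD0 : 0 <= D0) by apply slope_bound_ge0.
  set (U0 := 2 + D0 * (b - R1)).
  assert (hU0 : 2 <= U0) by (unfold U0, b; assert (0 <= D0 * (R2 + 1 - R1)) by (apply Rmult_le_pos; lra); lra).
  set (gt := fun s => fhat f (Rmin s U0)).
  assert (Hgt : admissible gt) by (apply admissible_truncate; [apply admissible_fhat | lra]; auto).
  destruct (fhat_bounded f Hreg Heq 0 U0 ltac:(lra)) as [B [hB HB]].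
  assert (HBt : forall s, Rabs (gt s) <= B).
  { intros s. unfold gt. destruct (Rle_dec 0 (Rmin s U0)).
    - apply HB. split; [auto | apply Rmin_r].
    - rewrite fhat_neg, Rabs_R0 by lra. auto. }
  destruct (solution_exists_bounded p N R1 b d gt B hp hR1 ltac:(unfold b; lra) (proj1 Hgt) HBt)
    as [u [v Hs]].
  exists u, v. apply (is_solution_g_ext p N gt (fhat f) R1 d u v b Hs).
  intros r hr. unfold gt. rewrite Rmin_left; auto.
  assert (H := sol_u_bound p N gt R1 r d u v b hp hR1 Hgt hd ltac:(lra) Hs r ltac:(lra)).
  unfold gt in H. rewrite slope_bound_truncate in H by lra. fold D0 in H.
  apply Rabs_le_between in H.
  assert (D0 * (r - R1) <= D0 * (b - R1)) by (apply Rmult_le_compat_l; lra).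
  unfold U0. lra.
Qed.

(** * Continuous dependence *)

Lemma not_eventually_extraction (P : nat -> Prop) :
  ~ (exists n0, forall n, (n0 <= n)%nat -> P n) -> exists tau, extraction tau /\ forall k, ~ P (tau k).
Proof.
  intros Hno.
  assert (Hbad : forall n0, exists n, (n0 <= n)%nat /\ ~ P n).
  { intros n0. apply Classical_Prop.NNPP. intro hn. apply Hno. exists n0. intros n hn0.
    apply Classical_Prop.NNPP. intro hc. apply hn. exists n. auto. }
  set (pick := fun n0 => proj1_sig (constructive_indefinite_description _ (Hbad n0))).
  assert (Hpk : forall n0, (n0 <= pick n0)%nat /\ ~ P (pick n0)).
  { intros n0. unfold pick. destruct (constructive_indefinite_description _ (Hbad n0)) as [n Hn]. auto. }
  set (tau := fix tau (k : nat) : nat := match k with O => pick O | S k' => pick (S (tau k')) end).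
  exists tau. split.
  - intros k. simpl. destruct (Hpk (S (tau k))). lia.
  - intros k. destruct k; [apply (Hpk O) | apply (Hpk (S (tau k)))].
Qed.

Lemma unif_cv_right_end (Y : nat -> R -> R) z w a b K : a < b -> 0 <= K ->
  unif_cv Y z (fun x => a <= x <= b) ->
  (forall n x y, a <= x <= b -> a <= y <= b -> Rabs (Y n x - Y n y) <= K * Rabs (x - y)) ->
  (forall x, a <= x < b -> z x = w x) -> continuous w b ->
  unif_cv Y w (fun x => a <= x <= b).
Proof.
  intros hab hK HY HL Hzw Hw.
  assert (Hzb : z b = w b).
  { apply (eq_at_right_end_of_lipschitz z w a b K); auto.
    intros y hy. rewrite <- (Rabs_right (b - y)), (Rabs_minus_sym b y) by lra.
    apply (lipschitz_of_unif_cv Y z a b K); auto; split; lra. }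
  apply (unif_cv_ext Y Y z w); auto.
  intros y hy. destruct (Req_dec y b) as [->|]; [auto | apply Hzw; lra].
Qed.

Section SolutionFamilies.
Variables (p : R) (N : nat) (g : R -> R) (R1 R2 : R).
Hypothesis hp : 1 < p.
Hypothesis hR1 : 0 <= R1.
Hypothesis hR12 : R1 < R2.
Hypothesis Hg : admissible g.
Variable Bf : R.
Hypothesis hBf : 0 <= Bf.
Hypothesis HBf : forall s, Rabs s <= 1 + slope_bound p g * (R2 - R1) -> Rabs (g s) <= Bf.

Lemma solutions_subseq_limit (dn : nat -> R) (d : R) (U V : nat -> R -> R) (rsn : nat -> R) :
  (forall n, 0 <= dn n <= 1) -> Un_cv dn d ->
  (forall n, R2 < rsn n /\ is_solution_g p N g R1 (dn n) (U n) (V n) (rsn n)) ->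
  exists kap ut vt, extraction kap /\
    unif_cv (fun n => U (kap n)) ut (fun x => R1 <= x <= R2) /\
    unif_cv (fun n => V (kap n)) vt (fun x => R1 <= x <= R2) /\
    is_solution_g p N g R1 d ut vt R2.
Proof.
  intros hdn Hlim HUV.
  assert (Hs : forall n, is_solution_g p N g R1 (dn n) (U n) (V n) (rsn n)) by apply HUV.
  assert (hrs : forall n, R2 < rsn n) by apply HUV.
  set (D0 := slope_bound p g). assert (hD0 : 0 <= D0) by apply slope_bound_ge0.
  set (Ub := 1 + D0 * (R2 - R1)). set (LV := R2 ^ (N - 1) * Bf).
  assert (hLV : 0 <= LV) by (apply Rmult_le_pos; [apply pow_le | ]; lra).
  assert (HUl : forall n x y, R1 <= x <= R2 -> R1 <= y <= R2 -> Rabs (U n x - U n y) <= D0 * Rabs (x - y))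
    by (intros; apply (sol_u_lipschitz p N g R1 R2 (dn n) (U n) (V n) (rsn n)); auto).
  assert (HVl : forall n x y, R1 <= x <= R2 -> R1 <= y <= R2 -> Rabs (V n x - V n y) <= LV * Rabs (x - y))
    by (intros; apply (sol_v_lipschitz p N g R1 R2 (dn n) (U n) (V n) (rsn n)); auto).
  assert (HUb : forall n x, R1 <= x <= R2 -> Rabs (U n x) <= Ub)
    by (intros; apply (sol_u_bound p N g R1 R2 (dn n) (U n) (V n) (rsn n)); auto).
  assert (HVb : forall n x, R1 <= x <= R2 -> Rabs (V n x) <= LV * (R2 - R1))
    by (intros; apply (sol_v_bound_unif p N g R1 R2 (dn n) (U n) (V n) (rsn n)); auto).
  destruct (Arzela_Ascoli2 U V R1 R2 Ub (LV * (R2 - R1)) D0 LV) as [kap [ut [vt [Hkap [Hu Hv]]]]];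
    auto; try lra.
  exists kap, ut, vt. split; [auto | split; [auto | split; [auto |]]].
  assert (HcV := fun x hx => unif_cv_Un_cv _ _ (fun x => R1 <= x <= R2) x Hv hx).
  assert (Hub := unif_cv_bound _ _ _ Ub Hu (fun n => HUb (kap n))).
  assert (Hvb := unif_cv_bound _ _ _ (LV * (R2 - R1)) Hv (fun n => HVb (kap n))).
  apply (limit_is_solution p N g R1 R2 d (fun n => U (kap n)) (fun n => V (kap n))
     (fun n y => phi_p_inv p (V (kap n) y / y ^ (N - 1)))
     (fun n y => - (y ^ (N - 1) * g (U (kap n) y))) ut vt D0 LV Bf);
    auto; [apply Hg | | | | |].
  - apply (UL_sequence (fun n => U (kap n) R1)); [apply (unif_cv_Un_cv _ _ _ R1 Hu); lra |].
    apply (Un_cv_ext (fun n => 1 - dn (kap n))); [intros n; rewrite (sol_u_init (Hs (kap n))); auto |].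
    apply CV_minus; [intros e he; exists O; intros; unfold Rdist; rewrite Rminus_eq_0, Rabs_R0; lra |].
    apply Un_cv_extraction; auto.
  - apply (Un_cv_const_eq _ _ _ (HcV R1 ltac:(lra))). intros n. apply (sol_v_init (Hs (kap n))).
  - intros n y hy. specialize (hrs (kap n)).
    split; [apply (sol_derive_u hR1 (Hs (kap n))) | apply (sol_derive_v hR1 (Hs (kap n)))]; lra.
  - intros c1 c2 hc1 hc12 hc2. split.
    + apply (unif_cv_phi_w p N _ _ c1 c2 (LV * (R2 - R1))); auto; [lra | | intros; apply Hvb; lra].
      apply (unif_cv_sub _ _ (fun x => R1 <= x <= R2)); auto. intros; lra.
    + apply (unif_cv_source N g _ _ c1 c2 Ub); auto; [lra | apply Hg | | intros; apply Hub; lra].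
      apply (unif_cv_sub _ _ (fun x => R1 <= x <= R2)); auto. intros; lra.
  - intros x hx. apply (Un_cv_bound _ _ _ (HcV x ltac:(lra))). intros n.
    apply (sol_v_bound p N g R1 R2 (dn (kap n)) (U (kap n)) (V (kap n)) (rsn (kap n))); auto; lra.
Qed.

Lemma solutions_subseq_converge (dn : nat -> R) (d : R) (U V : nat -> R -> R) (rsn : nat -> R)
    (u v : R -> R) (rs K : R) :
  (1 <= N)%nat -> 0 < K -> (forall s, Rabs s <= 1 -> Rabs (g s) <= K * Rpower0 (Rabs s) (p - 1)) ->
  locally_lipschitz_on_pos g ->
  (forall n, 0 <= dn n <= 1) -> Un_cv dn d -> 0 <= d <= 1 ->
  (forall n, R2 < rsn n /\ is_solution_g p N g R1 (dn n) (U n) (V n) (rsn n)) ->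
  R2 < rs -> is_solution_g p N g R1 d u v rs ->
  exists kap, unif_cv (fun n => U (kap n)) u (fun x => R1 <= x <= R2) /\
    unif_cv (fun n => V (kap n)) v (fun x => R1 <= x <= R2).
Proof.
  intros hN hK HK Hlip hdn Hlim hd HUV hrs Hs.
  destruct (solutions_subseq_limit dn d U V rsn hdn Hlim HUV) as [kap [ut [vt [Hkap [Hu [Hv Hst]]]]]].
  assert (Heqs : forall r, R1 <= r < R2 -> ut r = u r /\ vt r = v r)
    by (intros r hr; apply (solution_unique p N g R1 d ut vt u v R2 rs K); auto; lra).
  exists kap. split.
  - apply (unif_cv_right_end _ ut u R1 R2 (slope_bound p g)); auto; [apply slope_bound_ge0 | | |].
    + intros n x y hx hy. destruct (HUV (kap n)) as [hr Hsn].
      apply (sol_u_lipschitz p N g R1 R2 (dn (kap n)) _ (V (kap n)) (rsn (kap n))); auto.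
    + intros x hx. apply Heqs; auto.
    + apply (sol_continuous_u hR1 Hs). lra.
  - apply (unif_cv_right_end _ vt v R1 R2 (R2 ^ (N - 1) * Bf)); auto;
      [apply Rmult_le_pos; [apply pow_le |]; lra | | |].
    + intros n x y hx hy. destruct (HUV (kap n)) as [hr Hsn].
      apply (sol_v_lipschitz p N g R1 R2 (dn (kap n)) (U (kap n)) _ (rsn (kap n))); auto.
    + intros x hx. apply Heqs; auto.
    + apply (sol_continuous_v hR1 Hs). lra.
Qed.

End SolutionFamilies.
Theorem continuous_dependence (p : R) (N : nat) (f : R -> R) (R1 R2 : R) :
  1 < p -> (1 <= N)%nat -> 0 <= R1 -> R1 < R2 -> f_reg f -> f_eq f -> f_0 p f ->
  forall (dn : nat -> R) (d : R) (U V : nat -> R -> R) (rsn : nat -> R) (u v : R -> R) (rs : R),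
  (forall n, 0 <= dn n <= 1) -> Un_cv dn d -> 0 <= d <= 1 ->
  (forall n, R2 < rsn n /\ is_solution_g p N (fhat f) R1 (dn n) (U n) (V n) (rsn n)) ->
  R2 < rs -> is_solution_g p N (fhat f) R1 d u v rs ->
  forall eps, 0 < eps -> exists n0 : nat, forall n, (n0 <= n)%nat ->
    forall r, R1 <= r <= R2 -> Rabs (U n r - u r) < eps /\ Rabs (V n r - v r) < eps.
Proof.
  intros hp hN hR1 hR12 Hreg Heq Hf0 dn d U V rsn u v rs hdn Hlim hd HUV hrs Hs eps he.
  set (g := fhat f). assert (Hg : admissible g) by (apply admissible_fhat; auto).
  set (Ub := 1 + slope_bound p g * (R2 - R1)).
  assert (hUb : 0 <= Ub) by (assert (0 <= slope_bound p g * (R2 - R1))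
                               by (apply Rmult_le_pos; [apply slope_bound_ge0 | lra]); unfold Ub; lra).
  destruct (fhat_bounded f Hreg Heq (- Ub) Ub ltac:(lra)) as [Bf [hBf HBf]].
  destruct (Classical_Prop.classic (exists n0 : nat, forall n, (n0 <= n)%nat ->
    forall r, R1 <= r <= R2 -> Rabs (U n r - u r) < eps /\ Rabs (V n r - v r) < eps)) as [|Hno];
    [auto | exfalso].
  destruct (not_eventually_extraction _ Hno) as [tau [Htau Htb]].
  destruct (fhat_growth_at_0 f Hreg Heq p hp Hf0) as [K [hK HK]].
  destruct (solutions_subseq_converge p N g R1 R2 hp hR1 hR12 Hg Bf hBf
              ltac:(intros s hs; apply HBf, Rabs_le_between, hs)
              (fun k => dn (tau k)) d (fun k => U (tau k)) (fun k => V (tau k)) (fun k => rsn (tau k))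
              u v rs K hN hK HK (fhat_locally_lipschitz f Hreg)
              (fun k => hdn (tau k)) (Un_cv_extraction dn d tau Htau Hlim) hd (fun k => HUV (tau k)) hrs Hs)
    as [kap [Hu Hv]].
  destruct (Hu (eps/2) ltac:(lra)) as [N1 HN1]. destruct (Hv (eps/2) ltac:(lra)) as [N2 HN2].
  apply (Htb (kap (max N1 N2))). intros r hr.
  specialize (HN1 (max N1 N2) ltac:(lia) r hr). specialize (HN2 (max N1 N2) ltac:(lia) r hr).
  split; lra.
Qed.

Theorem lemma2p2 (p : R) (N : nat) (R1 R2 : R) (f : R -> R) :
  1 < p -> (1 <= N)%nat -> 0 <= R1 -> R1 < R2 ->
  f_reg f -> f_eq f -> f_0 p f -> f_1 p f ->
  (forall d, 0 <= d <= 1 ->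
     (exists (u v : R -> R) (rs : R), R2 < rs /\ is_solution p N f R1 d u v rs) /\
     (forall (u1 v1 : R -> R) (rs1 : R) (u2 v2 : R -> R) (rs2 : R),
        is_solution p N f R1 d u1 v1 rs1 ->
        is_solution p N f R1 d u2 v2 rs2 ->
        forall r, R1 <= r -> r < rs1 -> r < rs2 ->
          u1 r = u2 r /\ v1 r = v2 r)) /\
  (forall (dn : nat -> R) (d : R) (U V : nat -> R -> R) (rsn : nat -> R)
          (u v : R -> R) (rs : R),
     (forall n, 0 < dn n < 1) -> is_lim_seq dn d -> 0 <= d <= 1 ->
     (forall n, R2 < rsn n /\ is_solution p N f R1 (dn n) (U n) (V n) (rsn n)) ->
     R2 < rs -> is_solution p N f R1 d u v rs ->
     forall eps, 0 < eps -> exists n0 : nat, forall n, (n0 <= n)%nat ->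
       forall r, R1 <= r <= R2 ->
         Rabs (U n r - u r) < eps /\ Rabs (V n r - v r) < eps).
Proof.
  intros hp hN hR1 hR12 Hreg Heq Hf0 _.
  destruct (fhat_growth_at_0 f Hreg Heq p hp Hf0) as [K [hK HK]].
  split.
  - intros d hd. split.
    + destruct (solution_exists p N f R1 R2 d hp hR1 hR12 Hreg Heq hd) as [u [v Hs]].
      exists u, v, (R2 + 1). split; [lra | exact Hs].
    + intros u1 v1 rs1 u2 v2 rs2 Hs1 Hs2.
      apply (solution_unique p N (fhat f) R1 d u1 v1 u2 v2 rs1 rs2 K); auto.
      * apply admissible_fhat; auto.
      * apply fhat_locally_lipschitz; auto.
  - intros dn d U V rsn u v rs Hdn Hlim.
    apply (continuous_dependence p N f R1 R2); auto.
    + intros n. specialize (Hdn n). lra.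
    + apply is_lim_seq_Reals, Hlim.
Qed.
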